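(* For every $\mathcal{L}_{A}^{\Box}$-formula $\varphi$ the following are equivalent: (1) there exists a closed complete $\mathsf{LK'(A)}$-tableau for $\varphi$; (2) $\varphi$ is $\mathsf{LK(A)}$-derivable; (3) $\varphi$ is $\mathsf{K(A)}$-valid.
   Context: $\mathcal{L}_{A}^{\Box}$-formulas are built from a countably infinite set $\mathrm{Var}$ of variables with binary $\wedge,\vee,\&,\to$, constant $\overline{0}$, unary $\Box$; complexity of a formula = number of connective occurrences. A $\mathsf{K(A)}$-model $\langle W,R,V\rangle$: nonempty $W$, $R\subseteq W\times W$, $V\colon\mathrm{Var}\times W\to[-r,r]$ for some real $r\ge0$, extended by $\wedge=\min$, $\vee=\max$, $\&=+$, $V(\varphi\to\psi,x)=V(\psi,x)-V(\varphi,x)$, $V(\overline{0},x)=0$, $V(\Box\varphi,x)=\inf_{\mathbb{R}}\{V(\varphi,y):Rxy\}$ (empty infimum $=0$). $\varphi$ is $\mathsf{K(A)}$-valid if $V(\varphi,x)\ge0$ in all models at all worlds. Calculus $\mathsf{LK(A)}$: a labelled formula is a pair $\varphi^{k}$ (formula, natural number); $n\,\varphi^{k}$ denotes $n$ copies. Nodes are labelled inequations $\Gamma\rhd\Delta$ ($\rhd\in\{>,\ge\}$, $\Gamma,\Delta$ finite multisets of labelled formulas) or relations $rij$. A tableau is a finite tree of nodes grown by rules: if the nodes above the line occur on a branch, the branch may be extended by the nodes below, except branching rules, which split the branch into two, each extended by one alternative; $\rhd$ is preserved. Rules: ($\overline{0}\rhd$) $\Gamma,\overline{0}^{i}\rhd\Delta$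 gives $\Gamma\rhd\Delta$; ($\rhd\overline{0}$) $\Gamma\rhd\overline{0}^{i},\Delta$ gives $\Gamma\rhd\Delta$; ($\&\rhd$) $\Gamma,(\varphi\&\psi)^{i}\rhd\Delta$ gives $\Gamma,\varphi^{i},\psi^{i}\rhd\Delta$; ($\rhd\&$) $\Gamma\rhd(\varphi\&\psi)^{i},\Delta$ gives $\Gamma\rhd\varphi^{i},\psi^{i},\Delta$; ($\to\rhd$) $\Gamma,(\varphi\to\psi)^{i}\rhd\Delta$ gives $\Gamma,\psi^{i}\rhd\varphi^{i},\Delta$; ($\rhd\to$) $\Gamma\rhd(\varphi\to\psi)^{i},\Delta$ gives $\Gamma,\varphi^{i}\rhd\psi^{i},\Delta$; ($\wedge\rhd$) $\Gamma,(\varphi\wedge\psi)^{i}\rhd\Delta$ gives both $\Gamma,\varphi^{i}\rhd\Delta$ and $\Gamma,\psi^{i}\rhd\Delta$; ($\rhd\wedge$, branching) $\Gamma\rhd(\varphi\wedge\psi)^{i},\Delta$ gives $\Gamma\rhd\varphi^{i},\Delta$ or $\Gamma\rhd\psi^{i},\Delta$; ($\vee\rhd$, branching) $\Gamma,(\varphi\vee\psi)^{i}\rhd\Delta$ gives $\Gamma,\varphi^{i}\rhd\Delta$ or $\Gamma,\psi^{i}\rhd\Delta$; ($\rhd\vee$) $\Gamma\rhd(\varphi\vee\psi)^{i},\Delta$ gives both $\Gamma\rhd\varphi^{i},\Delta$ and $\Gamma\rhd\psi^{i},\Delta$; ($\Box\rhd$) from $rij$ and $\Gamma,(\Box\varphi)^{i}\rhd\Delta$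 add $\varphi^{j}\ge(\Box\varphi)^{i}$; ($\rhd\Box$) from $\Gamma\rhd(\Box\varphi)^{i},\Delta$ add $(\Box\varphi)^{i}\ge\varphi^{j}$ and $rij$, $j$ a new label; (ex) from $rik$ add $rkj$, $j$ new. The system associated to a branch consists of the inequations on it containing only labelled formulas $p^{i}$ ($p\in\mathrm{Var}$) and $(\Box\psi)^{i}$, treated as real variables with each side read as a sum (empty sum $=0$); a branch is closed if the system is unsatisfiable over $\mathbb{R}$, a tableau is closed if all branches are. A tableau for $\varphi$ has root $[\,]>[\varphi^{1}]$ followed by $r12$; $\varphi$ is $\mathsf{LK(A)}$-derivable if some tableau for $\varphi$ is closed. Calculus $\mathsf{LK'(A)}$: for each formula $\Box\varphi$ introduce a new variable $[\Box\varphi]$; $\mathrm{Var}^{*}=\mathrm{Var}\cup\{[\Box\varphi]\}$, formulas are over $\mathrm{Var}^{*}$; the complexity of a labelled inequation is the sum of complexities of its formula occurrences. $\mathsf{LK'(A)}$ has the rules of $\mathsf{LK(A)}$ for $\overline{0},\&,\to,\wedge,\vee$ and (ex), with the two box rules replaced by: ($\Box\rhd'$) from relations $rij_1,\dots,rij_s$ and inequations $\Gamma_t,n_t(\Box\varphi)^{i}\rhd\Delta_t$ ($t=1,\dots,m$) add $\varphi^{j_1}\ge[\Box\varphi]^{i},\dots,\varphi^{j_s}\ge[\Box\varphi]^{i}$ and $\Gamma_t,n_t[\Box\varphi]^{i}\rhd\Delta_t$ ($t=1,\dots,m$); ($\rhd\Box'$) from $\Gamma_t\rhd n_t(\Box\varphi)^{i},\Delta_t$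 ($t=1,\dots,m$) add $[\Box\varphi]^{i}\ge\varphi^{j}$, $rij$ and $\Gamma_t\rhd n_t[\Box\varphi]^{i},\Delta_t$ ($t=1,\dots,m$), with $j$ new. Closedness is as for $\mathsf{LK(A)}$ except that the associated system consists of the inequations containing only labelled formulas $q^{i}$ with $q\in\mathrm{Var}^{*}$. A complete $\mathsf{LK'(A)}$-tableau for $\varphi$ is built as follows, marking inequations active/inactive: (1) start with the active inequation $[\,]>[\varphi^{1}]$ and relation $r12$; (2) if all active labelled inequations have complexity $0$, stop; (3) apply the rules for $\overline{0},\&,\to,\wedge,\vee$ exhaustively to active inequations, making the premise inactive and the conclusions active after each application; (4) fix $i$ such that some $(\Box\psi)^{i}$ occurs in an active inequation, and apply (ex) to every branch $B$ containing $(\Box\chi)^{i}$ for some $\Box\chi$ in an active inequation, obtaining relations $rik_B$ for new $k_B$; (5) for each $(\Box\psi)^{i}$ occurring on the right of an active inequation, apply ($\rhd\Box'$) to the collection of all active inequations $\Gamma_t\rhd n_t(\Box\psi)^{i},\Delta_t$ on a branch (with $(\Box\psi)^{i}$ not in $\Delta_t$), making premises inactive and conclusions active; (6) for each $(\Box\psi)^{i}$ occurring on the left of an active inequation, apply ($\Box\rhd'$) to all active inequations $\Gamma_t,n_t(\Box\psi)^{i}\rhd\Delta_t$ (with $(\Box\psi)^{i}$ not in $\Gamma_t$) and all relations $rij_1,\dots,rij_s$ on a branch, making premises inactive and conclusions active; (7) repeat from (2). *)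

From Stdlib Require Import Reals List Permutation Relations ClassicalEpsilon.
From Coquelicot Require Import Rbar Lub.
Import ListNotations.
Open Scope R_scope.

(* Formulas.  [Var p] : p ∈ Var = nat.  [BVar φ] is the fresh variable
   [□φ] of LK'(A) (an atom); L_A^□-formulas are the [pure] ones.      *)
Inductive form : Type :=
| Var  : nat -> form
| BVar : form -> form
| Zero : form
| Conj : form -> form -> form
| Disj : form -> form -> form
| Amp  : form -> form -> form
| Imp  : form -> form -> form
| Box  : form -> form.

Fixpoint pure (f : form) : Prop :=
  match f with
  | Var _ | Zero => True
  | BVar _ => False
  | Conj a b | Disj a b | Amp a b | Imp a b => pure a /\ pure b
  | Box a => pure a
  end.

Fixpoint cplx (f : form) : nat :=
  match f with
  | Var _ | BVar _ => 0
  | Zero => 1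
  | Conj a b | Disj a b | Amp a b | Imp a b => S (cplx a + cplx b)
  | Box a => S (cplx a)
  end.

Definition form_eq_dec : forall x y : form, {x = y} + {x <> y}.
Proof. decide equality; apply PeanoNat.Nat.eq_dec. Defined.

(* infimum in R of a set, with the convention inf ∅ = 0 (for a nonempty
   set bounded below, [Glb_Rbar] is its infimum) *)
Definition infR (S : R -> Prop) : R :=
  if excluded_middle_informative (exists t, S t) then real (Glb_Rbar S) else 0.

Fixpoint eval {W : Type} (Rel : W -> W -> Prop) (V : nat -> W -> R)
         (f : form) (x : W) : R :=
  match f with
  | Var p => V p x
  | BVar _ => 0
  | Zero => 0
  | Conj a b => Rmin (eval Rel V a x) (eval Rel V b x)
  | Disj a b => Rmax (eval Rel V a x) (eval Rel V b x)
  | Amp a b => eval Rel V a x + eval Rel V b x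
  | Imp a b => eval Rel V b x - eval Rel V a x
  | Box a => infR (fun t => exists y, Rel x y /\ t = eval Rel V a y)
  end.

Definition KA_valid (phi : form) : Prop :=
  forall (W : Type) (Rel : W -> W -> Prop) (V : nat -> W -> R) (r : R),
    0 <= r -> (forall p x, Rabs (V p x) <= r) ->
    forall x : W, 0 <= eval Rel V phi x.

Definition lf : Type := (form * nat)%type.

(* Γ ▷ Δ ; [strict = true] means ▷ is >, [false] means ≥.
   Multisets are represented by lists (taken up to permutation). *)
Record ineq : Type := mkI { lhs : list lf; strict : bool; rhs : list lf }.

Inductive node : Type :=
| NI : ineq -> node
| NR : nat -> nat -> node.

Definition node_labels (n : node) : list nat :=
  match n with
  | NI P => map snd (lhs P ++ rhs P)
  | NR i j => [i; j]
  end.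

(* system associated to a list of inequations: the inequations all of whose
   labelled formulas satisfy [atom]; variables are the labelled formulas *)
Definition sumv (v : form -> nat -> R) (l : list lf) : R :=
  fold_right (fun x acc => v (fst x) (snd x) + acc) 0 l.

Definition holds (v : form -> nat -> R) (P : ineq) : Prop :=
  if strict P then sumv v (rhs P) < sumv v (lhs P)
  else sumv v (rhs P) <= sumv v (lhs P).

Definition sat_sys (atom : form -> Prop) (Ps : list ineq) : Prop :=
  exists v : form -> nat -> R,
    forall P, In P Ps -> (forall x, In x (lhs P ++ rhs P) -> atom (fst x)) ->
      holds v P.

Definition atomLK (f : form) : Prop :=
  match f with Var _ | Box _ => True | _ => False end.
Definition atomLK' (f : form) : Prop :=
  match f with Var _ | BVar _ => True | _ => False end.

Inductive alt : Type :=
| One : list ineq -> alt          (* non-branching: add all these nodes *)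
| Two : ineq -> ineq -> alt.      (* branching: two alternatives *)

Inductive prop_rule : ineq -> alt -> Prop :=
| r_zero_l G s D i : prop_rule (mkI ((Zero, i) :: G) s D) (One [mkI G s D])
| r_zero_r G s D i : prop_rule (mkI G s ((Zero, i) :: D)) (One [mkI G s D])
| r_amp_l G s D a b i :
    prop_rule (mkI ((Amp a b, i) :: G) s D) (One [mkI ((a, i) :: (b, i) :: G) s D])
| r_amp_r G s D a b i :
    prop_rule (mkI G s ((Amp a b, i) :: D)) (One [mkI G s ((a, i) :: (b, i) :: D)])
| r_imp_l G s D a b i :
    prop_rule (mkI ((Imp a b, i) :: G) s D) (One [mkI ((b, i) :: G) s ((a, i) :: D)])
| r_imp_r G s D a b i :
    prop_rule (mkI G s ((Imp a b, i) :: D)) (One [mkI ((a, i) :: G) s ((b, i) :: D)])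
| r_and_l G s D a b i :
    prop_rule (mkI ((Conj a b, i) :: G) s D)
              (One [mkI ((a, i) :: G) s D; mkI ((b, i) :: G) s D])
| r_and_r G s D a b i :
    prop_rule (mkI G s ((Conj a b, i) :: D))
              (Two (mkI G s ((a, i) :: D)) (mkI G s ((b, i) :: D)))
| r_or_l G s D a b i :
    prop_rule (mkI ((Disj a b, i) :: G) s D)
              (Two (mkI ((a, i) :: G) s D) (mkI ((b, i) :: G) s D))
| r_or_r G s D a b i :
    prop_rule (mkI G s ((Disj a b, i) :: D))
              (One [mkI G s ((a, i) :: D); mkI G s ((b, i) :: D)]).

Definition prop_app (P : ineq) (a : alt) : Prop :=
  exists P', Permutation (lhs P) (lhs P') /\ Permutation (rhs P) (rhs P') /\
             strict P = strict P' /\ prop_rule P' a.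

(* LK(A): closed tableaux, described branch by branch.
   [lk_closed B] : the branch B (list of its nodes) can be grown into a
   finite subtree all of whose branches are closed. *)
Definition ineqs_of (B : list node) : list ineq :=
  flat_map (fun n => match n with NI P => [P] | NR _ _ => [] end) B.

Definition fresh (j : nat) (B : list node) : Prop :=
  ~ In j (flat_map node_labels B).

Inductive lk_closed : list node -> Prop :=
| lk_unsat B : ~ sat_sys atomLK (ineqs_of B) -> lk_closed B
| lk_prop1 B P cs :
    In (NI P) B -> prop_app P (One cs) ->
    lk_closed (B ++ map NI cs) -> lk_closed B
| lk_prop2 B P c1 c2 :
    In (NI P) B -> prop_app P (Two c1 c2) ->
    lk_closed (B ++ [NI c1]) -> lk_closed (B ++ [NI c2]) -> lk_closed B
| lk_box_l B P phi i j :
    In (NR i j) B -> In (NI P) B -> In (Box phi, i) (lhs P) ->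
    lk_closed (B ++ [NI (mkI [(phi, j)] false [(Box phi, i)])]) -> lk_closed B
| lk_box_r B P phi i j :
    In (NI P) B -> In (Box phi, i) (rhs P) -> fresh j B ->
    lk_closed (B ++ [NI (mkI [(Box phi, i)] false [(phi, j)]); NR i j]) ->
    lk_closed B
| lk_ex B i k j :
    In (NR i k) B -> fresh j B -> lk_closed (B ++ [NR k j]) -> lk_closed B.

Definition LKA_derivable (phi : form) : Prop :=
  lk_closed [NI (mkI [] true [(phi, 1%nat)]); NR 1 2].

(* A tableau is represented by the list of its
   branches; a branch is a list of nodes with an activity mark
   (true = active; relations carry [false], which is irrelevant). *)
Definition mnode : Type := (node * bool)%type.
Definition branch : Type := list mnode.
Definition state : Type := list branch.

Definition act (P : ineq) : mnode := (NI P, true).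
Definition bnodes (b : branch) : list node := map fst b.
Definition bfresh (j : nat) (b : branch) : Prop := fresh j (bnodes b).

Inductive pstep : branch -> list branch -> Prop :=
| ps_one b1 b2 P cs :
    prop_app P (One cs) ->
    pstep (b1 ++ (NI P, true) :: b2) [b1 ++ (NI P, false) :: b2 ++ map act cs]
| ps_two b1 b2 P c1 c2 :
    prop_app P (Two c1 c2) ->
    pstep (b1 ++ (NI P, true) :: b2)
          [b1 ++ (NI P, false) :: b2 ++ [act c1];
           b1 ++ (NI P, false) :: b2 ++ [act c2]].

Inductive gstep3 : state -> state -> Prop :=
| g3 S1 b S2 bs : pstep b bs -> gstep3 (S1 ++ b :: S2) (S1 ++ bs ++ S2).

Definition is_box_or_atom (f : form) : Prop :=
  match f with Var _ | BVar _ | Box _ => True | _ => False end.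

Definition prop_exhausted (S : state) : Prop :=
  forall b P x, In b S -> In (NI P, true) b -> In x (lhs P ++ rhs P) ->
    is_box_or_atom (fst x).

Definition all_cplx0 (S : state) : Prop :=
  forall b P x, In b S -> In (NI P, true) b -> In x (lhs P ++ rhs P) ->
    cplx (fst x) = 0%nat.

Definition has_box_at (i : nat) (b : branch) : Prop :=
  exists P psi, In (NI P, true) b /\ In (Box psi, i) (lhs P ++ rhs P).

Definition step4 (i : nat) (b b' : branch) : Prop :=
  (has_box_at i b /\ exists k, bfresh k b /\ b' = b ++ [(NR i k, false)]) \/
  (~ has_box_at i b /\ b' = b).

Definition lf_eqb (x y : lf) : bool :=
  if form_eq_dec (fst x) (fst y) then PeanoNat.Nat.eqb (snd x) (snd y) else false.

Definition repl (psi : form) (i : nat) (l : list lf) : list lf :=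
  map (fun x => if lf_eqb x (Box psi, i) then (BVar psi, i) else x) l.

Definition hasR (psi : form) (i : nat) (m : mnode) : bool :=
  match m with
  | (NI P, true) => existsb (lf_eqb (Box psi, i)) (rhs P)
  | _ => false
  end.
Definition hasL (psi : form) (i : nat) (m : mnode) : bool :=
  match m with
  | (NI P, true) => existsb (lf_eqb (Box psi, i)) (lhs P)
  | _ => false
  end.

Definition deact (h : mnode -> bool) (b : branch) : branch :=
  map (fun m => if h m then (fst m, false) else m) b.

Definition concl5 (psi : form) (i : nat) (b : branch) : branch :=
  flat_map (fun m => if hasR psi i m then
                       match fst m with
                       | NI P => [act (mkI (lhs P) (strict P) (repl psi i (rhs P)))]
                       | NR _ _ => []
                       end else []) b.
Definition concl6 (psi : form) (i : nat) (b : branch) : branch :=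
  flat_map (fun m => if hasL psi i m then
                       match fst m with
                       | NI P => [act (mkI (repl psi i (lhs P)) (strict P) (rhs P))]
                       | NR _ _ => []
                       end else []) b.

Definition succs (i : nat) (b : branch) : list nat :=
  flat_map (fun m => match fst m with
                     | NR i' j => if PeanoNat.Nat.eqb i i' then [j] else []
                     | NI _ => [] end) b.

Definition step5_one (i : nat) (b b' : branch) : Prop :=
  exists psi j, existsb (hasR psi i) b = true /\ bfresh j b /\
    b' = deact (hasR psi i) b ++ concl5 psi i b ++
         [act (mkI [(BVar psi, i)] false [(psi, j)]); (NR i j, false)].

Definition step6_one (i : nat) (b b' : branch) : Prop :=
  exists psi, existsb (hasL psi i) b = true /\
    b' = deact (hasL psi i) b ++ concl6 psi i b ++
         map (fun j => act (mkI [(psi, j)] false [(BVar psi, i)])) (succs i b).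

Definition step5 (i : nat) (b b' : branch) : Prop :=
  clos_refl_trans_1n _ (step5_one i) b b' /\
  forall psi, existsb (hasR psi i) b' = false.
Definition step6 (i : nat) (b b' : branch) : Prop :=
  clos_refl_trans_1n _ (step6_one i) b b' /\
  forall psi, existsb (hasL psi i) b' = false.

Definition step456 (i : nat) (S S' : state) : Prop :=
  Forall2 (fun b b' => exists b4 b5, step4 i b b4 /\ step5 i b4 b5 /\ step6 i b5 b')
          S S'.

Inductive complete_run : state -> state -> Prop :=
| cr_stop S : all_cplx0 S -> complete_run S S
| cr_round S S3 S6 F :
    ~ all_cplx0 S ->
    clos_refl_trans_1n _ gstep3 S S3 -> prop_exhausted S3 ->
    ((exists i, (exists b, In b S3 /\ has_box_at i b) /\ step456 i S3 S6) \/
     (all_cplx0 S3 /\ S6 = S3)) ->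
    complete_run S6 F -> complete_run S F.

Definition init_state (phi : form) : state :=
  [[(NI (mkI [] true [(phi, 1%nat)]), true); (NR 1 2, false)]].

Definition closed' (F : state) : Prop :=
  Forall (fun b => ~ sat_sys atomLK' (ineqs_of (bnodes b))) F.

Definition closed_complete_LK'_tableau (phi : form) : Prop :=
  exists F, complete_run (init_state phi) F /\ closed' F.

(* (1) => (2): reading each fresh atom [□ψ] back as □ψ and renaming labels turns a complete
   LK'(A)-tableau into an LK(A)-tableau: (▷□') becomes (▷□), (□▷') becomes one application of
   (□▷) per successor, step (4) becomes (ex) unless a successor is already there, and a solution
   of an LK(A)-system yields one of the corresponding LK'(A)-system.

   (2) => (3): if V(φ, x) = -δ < 0 in a model, made serial by adding a dead end, then along
   every branch of a tableau the labels can be sent to worlds so that the strict inequations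
   hold with slack δ and the others up to any prescribed ε > 0; the ε is needed because (▷□)
   asks for a world where an infimum is attained.  By Fourier-Motzkin elimination a finite
   linear system that is satisfiable up to every ε is satisfiable, so no branch closes.

   (3) => (1): the complete procedure terminates, since each step decreases Σ_b 3^(Σ_P 3^w(P)),
   summing over the branches b and their active inequations P, with a weight w in which boxes
   weigh more than what one round of steps (5)-(6) can add.  If a final branch were open, a
   solution of its system, with the labels as worlds and the relations of the branch as
   accessibility, would be a countermodel: going back through the run every active inequation
   keeps holding, (□▷') being sound because a label processed in step (6) never gets new
   successors afterwards. *)

From Stdlib Require Import Reals Lra Lia Arith List Permutation Relations Classical ClassicalEpsilon.
From Stdlib Require Import FunctionalExtensionality PropExtensionality.
From Coquelicot Require Import Rbar Lub.
Import ListNotations.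
Open Scope R_scope.

(** * Infima and the semantics of the box *)

Lemma infR_glb (E : R -> Prop) (B t0 : R) : E t0 -> (forall t, E t -> -B <= t) ->
  (forall t, E t -> infR E <= t) /\ (forall c, (forall t, E t -> c <= t) -> c <= infR E).
Proof.
  intros Ht0 HB. unfold infR.
  destruct (excluded_middle_informative _) as [_|Hn]; [|exfalso; apply Hn; eauto].
  destruct (Glb_Rbar_correct E) as [Hlb Hgl].
  destruct (Glb_Rbar E) as [g| |] eqn:Hg; simpl.
  - split; [intros t Ht; exact (Hlb t Ht)|].
    intros c Hc. apply (Hgl (Finite c)). intros t Ht. apply Hc; auto.
  - exact (False_ind _ (Hlb t0 Ht0)).
  - exfalso. apply (Hgl (Finite (-B))). intros t Ht. apply HB; auto.
Qed.

Lemma infR_empty (E : R -> Prop) : ~ (exists t, E t) -> infR E = 0.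
Proof. intros H. unfold infR. destruct (excluded_middle_informative _); tauto. Qed.

Lemma infR_ext (E1 E2 : R -> Prop) : (forall t, E1 t <-> E2 t) -> infR E1 = infR E2.
Proof.
  intros H. f_equal. apply functional_extensionality. intros t.
  apply propositional_extensionality; auto.
Qed.

Lemma infR_singleton (c : R) : infR (fun t => t = c) = c.
Proof.
  destruct (infR_glb (fun t => t = c) (- c) c) as [H1 H2]; auto.
  - intros t ->; lra.
  - specialize (H1 c eq_refl). specialize (H2 c (fun t H => ltac:(subst; lra))). lra.
Qed.

Lemma infR_approx (E : R -> Prop) (B t0 eps : R) : E t0 -> (forall t, E t -> -B <= t) ->
  0 < eps -> exists t, E t /\ t < infR E + eps.
Proof.
  intros Ht0 HB He. destruct (infR_glb E B t0 Ht0 HB) as [_ Hgl].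
  apply NNPP; intros Hn.
  enough (infR E + eps <= infR E) by lra.
  apply Hgl. intros t Ht. apply Rnot_lt_le. intros Hlt. apply Hn; eauto.
Qed.

Fixpoint var_occs (f : form) : R :=
  match f with
  | Var _ => 1
  | BVar _ | Zero => 0
  | Conj a b | Disj a b | Amp a b | Imp a b => var_occs a + var_occs b
  | Box a => var_occs a
  end.

Lemma var_occs_ge0 (f : form) : 0 <= var_occs f.
Proof. induction f; simpl; lra. Qed.

Section BoundedModel.

Variables (W : Type) (Rel : W -> W -> Prop) (V : nat -> W -> R) (r : R).
Hypothesis r_ge0 : 0 <= r.
Hypothesis V_bounded : forall p x, Rabs (V p x) <= r.

Definition succ_values (a : form) (x : W) : R -> Prop :=
  fun t => exists y, Rel x y /\ t = eval Rel V a y.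

Lemma Rabs_eval_le (f : form) (x : W) : Rabs (eval Rel V f x) <= var_occs f * r.
Proof.
  revert x. induction f; intros x; simpl;
    try (pose proof (var_occs_ge0 f1); pose proof (var_occs_ge0 f2);
         specialize (IHf1 x); specialize (IHf2 x)).
  - rewrite Rmult_1_l; auto.
  - rewrite Rabs_R0; lra.
  - rewrite Rabs_R0; lra.
  - unfold Rmin; destruct (Rle_dec _ _); split_Rabs; nra.
  - unfold Rmax; destruct (Rle_dec _ _); split_Rabs; nra.
  - split_Rabs; nra.
  - split_Rabs; nra.
  - fold (succ_values f x).
    assert (Hs : forall t, succ_values f x t -> Rabs t <= var_occs f * r).
    { intros t [y [_ ->]]. apply IHf. }
    destruct (classic (exists t, succ_values f x t)) as [[t0 Ht0]|Hn].
    + destruct (infR_glb (succ_values f x) (var_occs f * r) t0 Ht0) as [H1 H2].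
      { intros t Ht. specialize (Hs t Ht). split_Rabs; lra. }
      pose proof (H1 t0 Ht0). pose proof (Hs t0 Ht0).
      assert (- (var_occs f * r) <= infR (succ_values f x)).
      { apply H2. intros t Ht. specialize (Hs t Ht). split_Rabs; lra. }
      split_Rabs; lra.
    + rewrite (infR_empty _ Hn), Rabs_R0. pose proof (var_occs_ge0 f). nra.
Qed.

Lemma succ_values_bounded (a : form) (x : W) :
  forall t, succ_values a x t -> - (var_occs a * r) <= t.
Proof. intros t [y [_ ->]]. pose proof (Rabs_eval_le a y). split_Rabs; lra. Qed.

Lemma eval_Box_le (a : form) (x y : W) : Rel x y -> eval Rel V (Box a) x <= eval Rel V a y.
Proof.
  intros Hxy. apply (infR_glb _ _ _ (ex_intro _ y (conj Hxy eq_refl)) (succ_values_bounded a x)).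
  exists y; auto.
Qed.

Lemma eval_Box_ge (a : form) (x : W) (c : R) : (exists y, Rel x y) ->
  (forall y, Rel x y -> c <= eval Rel V a y) -> c <= eval Rel V (Box a) x.
Proof.
  intros [y Hxy] Hc.
  apply (infR_glb _ _ _ (ex_intro _ y (conj Hxy eq_refl)) (succ_values_bounded a x)).
  intros t [z [Hz ->]]. auto.
Qed.

Lemma eval_Box_approx (a : form) (x : W) (eps : R) : (exists y, Rel x y) -> 0 < eps ->
  exists y, Rel x y /\ eval Rel V a y < eval Rel V (Box a) x + eps.
Proof.
  intros [y Hxy] He.
  destruct (infR_approx _ _ _ eps (ex_intro _ y (conj Hxy eq_refl)) (succ_values_bounded a x) He)
    as [t [[z [Hz ->]] Ht]].
  eauto.
Qed.

End BoundedModel.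

(* Adjoining a dead end [None] where every formula is worth 0, and an edge to it from every
   world without successors, makes the model serial without changing any value: the empty
   infimum was already 0. *)
Definition serial_rel {W : Type} (Rel : W -> W -> Prop) (a b : option W) : Prop :=
  match a, b with
  | Some x, Some y => Rel x y
  | Some x, None => ~ exists y, Rel x y
  | None, None => True
  | None, Some _ => False
  end.

Definition serial_val {W : Type} (V : nat -> W -> R) (p : nat) (a : option W) : R :=
  match a with Some x => V p x | None => 0 end.

Lemma eval_serial (W : Type) (Rel : W -> W -> Prop) (V : nat -> W -> R) (f : form) :
  (forall x, eval (serial_rel Rel) (serial_val V) f (Some x) = eval Rel V f x) /\
  eval (serial_rel Rel) (serial_val V) f None = 0.
Proof.
  induction f as [| | |f1 [A1 B1] f2 [A2 B2]|f1 [A1 B1] f2 [A2 B2]|f1 [A1 B1] f2 [A2 B2]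
                  |f1 [A1 B1] f2 [A2 B2]|f [A B]];
    simpl; try (split; [intros; reflexivity|reflexivity]);
    try (split; [intros x; rewrite A1, A2; reflexivity|rewrite B1, B2]);
    try (unfold Rmin, Rmax; destruct (Rle_dec _ _)); try lra.
  split.
  - intros x. destruct (classic (exists y, Rel x y)) as [Hs|Hn].
    + apply infR_ext. intros t; split.
      * intros [[y|] [Hy ->]]; simpl in Hy; [exists y; rewrite A; auto|contradiction].
      * intros [y [Hy ->]]. exists (Some y). simpl. rewrite A; auto.
    + rewrite (infR_empty (fun t => exists y, Rel x y /\ t = eval Rel V f y));
        [|intros [t [y [Hy _]]]; apply Hn; eauto].
      rewrite <- (infR_singleton 0). apply infR_ext. intros t; split.
      * intros [[y|] [Hy ->]]; simpl in Hy; [exfalso; apply Hn; eauto|auto].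
      * intros ->. exists None. simpl. auto.
  - rewrite <- (infR_singleton 0). apply infR_ext. intros t; split.
    + intros [[y|] [Hy ->]]; simpl in Hy; [contradiction|auto].
    + intros ->. exists None. simpl. auto.
Qed.

Lemma serial_rel_serial (W : Type) (Rel : W -> W -> Prop) (a : option W) :
  exists b, serial_rel Rel a b.
Proof.
  destruct a as [x|]; [|exists None; simpl; auto].
  destruct (classic (exists y, Rel x y)) as [[y Hy]|Hn];
    [exists (Some y)|exists None]; simpl; auto.
Qed.

Lemma serial_val_bounded (W : Type) (V : nat -> W -> R) (r : R) : 0 <= r ->
  (forall p x, Rabs (V p x) <= r) -> forall p a, Rabs (serial_val V p a) <= r.
Proof. intros hr hV p [x|]; simpl; auto. rewrite Rabs_R0; auto. Qed.

(** * Approximately feasible linear systems are feasible *)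

Definition lin {X : Type} (vs : list X) (a w : X -> R) : R :=
  fold_right (fun y acc => a y * w y + acc) 0 vs.

Lemma lin_comb {X : Type} (vs : list X) (a b w : X -> R) (s t : R) :
  lin vs (fun y => s * a y + t * b y) w = s * lin vs a w + t * lin vs b w.
Proof. induction vs; simpl; [lra|]. rewrite IHvs. ring. Qed.

Lemma lin_ext {X : Type} (vs : list X) (a b w w' : X -> R) :
  (forall y, In y vs -> a y * w y = b y * w' y) -> lin vs a w = lin vs b w'.
Proof. induction vs; simpl; intros H; auto. rewrite H, IHvs; auto. Qed.

Lemma lin_zero {X : Type} (vs : list X) (w : X -> R) : lin vs (fun _ => 0) w = 0.
Proof. induction vs; simpl; auto. rewrite IHvs; ring. Qed.

Lemma lin_indicator {X : Type} (dec : forall a b : X, {a = b} + {a <> b}) vs x w :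
  NoDup vs -> In x vs -> lin vs (fun y => if dec x y then 1 else 0) w = w x.
Proof.
  induction vs as [|a vs IH]; intros Hnd Hin; [destruct Hin|].
  inversion Hnd; subst. simpl. destruct (dec x a) as [->|Hne].
  - rewrite (lin_ext vs _ (fun _ => 0) _ w), lin_zero; [ring|].
    intros y Hy. destruct (dec a y); [subst; contradiction|ring].
  - destruct Hin as [->|Hin]; [contradiction|]. rewrite IH; auto. ring.
Qed.

(* [(a, c)] stands for the constraint [c <= lin vs a w]. *)
Definition constraint (X : Type) : Type := ((X -> R) * R)%type.

Definition approx_feasible {X : Type} (vs : list X) (cs : list (constraint X)) : Prop :=
  forall eps, 0 < eps -> exists w, forall k, In k cs -> snd k - eps <= lin vs (fst k) w.

Definition feasible {X : Type} (vs : list X) (cs : list (constraint X)) : Prop :=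
  exists w, forall k, In k cs -> snd k <= lin vs (fst k) w.

Lemma separating_point (A B : list R) : (forall a b, In a A -> In b B -> a <= b) ->
  exists t, (forall a, In a A -> a <= t) /\ (forall b, In b B -> t <= b).
Proof.
  induction A as [|a A IH]; intros H.
  - induction B as [|b B IHB]; [exists 0; split; intros ? []|].
    destruct IHB as [t [_ Ht]]; [intros ? ? []|].
    exists (Rmin b t). split; [intros ? []|].
    intros c [<-|Hc]; [apply Rmin_l|]. eapply Rle_trans; [apply Rmin_r|auto].
  - destruct IH as [t [H1 H2]]; [intros; apply H; simpl; auto|].
    exists (Rmax a t). split.
    + intros c [<-|Hc]; [apply Rmax_l|]. eapply Rle_trans; [apply H1; auto|apply Rmax_r].
    + intros b Hb. apply Rmax_lub; [apply H; simpl; auto|auto].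
Qed.

Lemma le_sum_nonneg {X : Type} (f : X -> R) (l : list X) (x : X) : (forall y, 0 <= f y) ->
  In x l -> f x <= fold_right (fun y acc => f y + acc) 0 l.
Proof.
  intros Hp. induction l as [|a l IH]; simpl; [tauto|]. intros [->|H].
  - enough (0 <= fold_right (fun y acc => f y + acc) 0 l) by lra.
    clear -Hp. induction l; simpl; [lra|]. specialize (Hp a). lra.
  - specialize (IH H). specialize (Hp a). lra.
Qed.

Lemma Rinv_Rabs_ge0 (r : R) : 0 <= / Rabs r.
Proof.
  destruct (Req_EM_T r 0) as [->|Hr].
  - rewrite Rabs_R0, Rinv_0; lra.
  - left; apply Rinv_0_lt_compat, Rabs_pos_lt; auto.
Qed.

Section Elimination.

Variables (X : Type) (dec : forall a b : X, {a = b} + {a <> b}) (x : X) (xs : list X).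

Definition zero_part (cs : list (constraint X)) :=
  filter (fun k => if Req_EM_T (fst k x) 0 then true else false) cs.
Definition pos_part (cs : list (constraint X)) :=
  filter (fun k => if Rlt_dec 0 (fst k x) then true else false) cs.
Definition neg_part (cs : list (constraint X)) :=
  filter (fun k => if Rlt_dec (fst k x) 0 then true else false) cs.

(* The positive combination of [p] and [n] in which the coefficient of [x] cancels. *)
Definition fm_comb (p n : constraint X) : constraint X :=
  (fun y => / (fst p x) * fst p y + / (- fst n x) * fst n y,
   / (fst p x) * snd p + / (- fst n x) * snd n).

Definition fm_elim (cs : list (constraint X)) : list (constraint X) :=
  zero_part cs ++ flat_map (fun p => map (fm_comb p) (neg_part cs)) (pos_part cs).

Lemma in_zero_part cs k : In k (zero_part cs) <-> In k cs /\ fst k x = 0.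
Proof.
  unfold zero_part. rewrite filter_In.
  destruct (Req_EM_T _ _); split; intros [? ?]; auto; try discriminate; contradiction.
Qed.

Lemma in_pos_part cs k : In k (pos_part cs) <-> In k cs /\ 0 < fst k x.
Proof.
  unfold pos_part. rewrite filter_In.
  destruct (Rlt_dec _ _); split; intros [? ?]; auto; try discriminate; contradiction.
Qed.

Lemma in_neg_part cs k : In k (neg_part cs) <-> In k cs /\ fst k x < 0.
Proof.
  unfold neg_part. rewrite filter_In.
  destruct (Rlt_dec _ _); split; intros [? ?]; auto; try discriminate; contradiction.
Qed.

Lemma in_fm_elim cs k : In k (fm_elim cs) <->
  In k (zero_part cs) \/
  exists p n, In p (pos_part cs) /\ In n (neg_part cs) /\ k = fm_comb p n.
Proof.
  unfold fm_elim. rewrite in_app_iff, in_flat_map. split.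
  - intros [H|[p [Hp Hk]]]; auto. right. apply in_map_iff in Hk.
    destruct Hk as [n [<- Hn]]. eauto.
  - intros [H|[p [n [Hp [Hn ->]]]]]; auto. right. exists p; split; auto. apply in_map; auto.
Qed.

Lemma lin_fm_comb p n w :
  lin xs (fst (fm_comb p n)) w = / (fst p x) * lin xs (fst p) w + / (- fst n x) * lin xs (fst n) w.
Proof. apply lin_comb. Qed.

Lemma fm_comb_approx p n w e : 0 < fst p x -> fst n x < 0 -> 0 <= e ->
  snd p - e <= lin (x :: xs) (fst p) w -> snd n - e <= lin (x :: xs) (fst n) w ->
  snd (fm_comb p n) - e * (/ fst p x + / (- fst n x)) <= lin xs (fst (fm_comb p n)) w.
Proof.
  intros Hpx Hnx He H1 H2. rewrite lin_fm_comb. simpl in H1, H2 |- *.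
  set (a := fst p x) in *. set (b := - fst n x).
  replace (fst n x) with (- b) in H2 by (unfold b; ring).
  assert (Hb : 0 < b) by (unfold b; lra).
  set (Lp := lin xs (fst p) w) in *. set (Ln := lin xs (fst n) w) in *.
  assert (A1 : / a * (snd p - e) <= / a * (a * w x + Lp))
    by (apply Rmult_le_compat_l; [apply Rlt_le, Rinv_0_lt_compat|]; lra).
  assert (A2 : / b * (snd n - e) <= / b * (- b * w x + Ln))
    by (apply Rmult_le_compat_l; [apply Rlt_le, Rinv_0_lt_compat|]; lra).
  replace (/ a * (a * w x + Lp)) with (w x + / a * Lp) in A1 by (field; lra).
  replace (/ b * (- b * w x + Ln)) with (- w x + / b * Ln) in A2 by (field; lra).
  nra.
Qed.

Lemma fm_elim_approx_feasible cs :
  approx_feasible (x :: xs) cs -> approx_feasible xs (fm_elim cs).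
Proof.
  intros Happ eps He.
  set (S0 := fold_right (fun k acc => / Rabs (fst k x) + acc) 0 cs).
  assert (HS0 : forall k, In k cs -> / Rabs (fst k x) <= S0).
  { intros k Hk. apply (le_sum_nonneg (fun k => / Rabs (fst k x))); auto.
    intros; apply Rinv_Rabs_ge0. }
  assert (HS0p : 0 <= S0).
  { unfold S0. clear. induction cs; simpl; [lra|]. pose proof (Rinv_Rabs_ge0 (fst a x)). lra. }
  set (e := eps / (2 * S0 + 1)).
  assert (He0 : 0 < e) by (apply Rdiv_lt_0_compat; lra).
  assert (Hee : e * (2 * S0 + 1) = eps) by (unfold e; field; lra).
  destruct (Happ e He0) as [w Hw]. exists w. intros k Hk.
  apply in_fm_elim in Hk. destruct Hk as [Hk|[p [n [Hp [Hn ->]]]]].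
  - apply in_zero_part in Hk. destruct Hk as [Hk Hkx]. specialize (Hw k Hk). simpl in Hw.
    rewrite Hkx in Hw. nra.
  - apply in_pos_part in Hp. destruct Hp as [Hp Hpx].
    apply in_neg_part in Hn. destruct Hn as [Hn Hnx].
    pose proof (fm_comb_approx p n w e Hpx Hnx (Rlt_le _ _ He0) (Hw p Hp) (Hw n Hn)) as Hc.
    pose proof (HS0 p Hp) as Mp. pose proof (HS0 n Hn) as Mn.
    rewrite Rabs_pos_eq in Mp by lra. rewrite Rabs_left in Mn by lra.
    assert (e * (/ fst p x + / - fst n x) <= e * (2 * S0 + 1))
      by (apply Rmult_le_compat_l; lra).
    lra.
Qed.

(* The positive (negative) constraints bound the value of [x] from below (above); the combined
   constraints say exactly that every lower bound is below every upper bound. *)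
Lemma fm_elim_bounds_separated cs w0 :
  (forall k, In k (fm_elim cs) -> snd k <= lin xs (fst k) w0) ->
  exists t, (forall p, In p (pos_part cs) -> (snd p - lin xs (fst p) w0) / fst p x <= t) /\
            (forall n, In n (neg_part cs) -> t <= (lin xs (fst n) w0 - snd n) / (- fst n x)).
Proof.
  intros Hw0.
  destruct (separating_point (map (fun p => (snd p - lin xs (fst p) w0) / fst p x) (pos_part cs))
              (map (fun n => (lin xs (fst n) w0 - snd n) / (- fst n x)) (neg_part cs)))
    as [t [Ht1 Ht2]];
    [|exists t; split; intros k Hk; [apply Ht1|apply Ht2]; exact (in_map _ _ _ Hk)].
  intros a b Ha Hb.
  apply in_map_iff in Ha. destruct Ha as [p [<- Hp]].
  apply in_map_iff in Hb. destruct Hb as [n [<- Hn]].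
  pose proof (Hw0 (fm_comb p n) (proj2 (in_fm_elim cs _) (or_intror (ex_intro _ p
    (ex_intro _ n (conj Hp (conj Hn eq_refl))))))) as Hc.
  rewrite lin_fm_comb in Hc. simpl in Hc.
  apply in_pos_part in Hp. destruct Hp as [_ Hpx]. apply in_neg_part in Hn. destruct Hn as [_ Hnx].
  unfold Rdiv. set (a := fst p x) in *. set (b := - fst n x) in *.
  assert (0 < b) by (unfold b; lra).
  set (Lp := lin xs (fst p) w0) in *. set (Ln := lin xs (fst n) w0) in *.
  nra.
Qed.

Lemma fm_elim_feasible cs : ~ In x xs ->
  feasible xs (fm_elim cs) -> feasible (x :: xs) cs.
Proof.
  intros Hx [w0 Hw0]. destruct (fm_elim_bounds_separated cs w0 Hw0) as [t [Ht1 Ht2]].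
  exists (fun y => if dec y x then t else w0 y).
  intros k Hk. simpl. destruct (dec x x) as [_|]; [|contradiction].
  rewrite (lin_ext xs _ (fst k) _ w0)
    by (intros y Hy; destruct (dec y x); [subst; contradiction|auto]).
  destruct (Rtotal_order (fst k x) 0) as [Hneg|[Hz|Hpos]].
  - assert (Hn : In k (neg_part cs)) by (apply in_neg_part; auto).
    specialize (Ht2 _ Hn).
    set (b := - fst k x) in *. replace (fst k x) with (- b) by (unfold b; ring).
    assert (0 < b) by (unfold b; lra).
    assert (Hbt : b * t <= b * ((lin xs (fst k) w0 - snd k) / b)) by (apply Rmult_le_compat_l; lra).
    replace (b * ((lin xs (fst k) w0 - snd k) / b)) with (lin xs (fst k) w0 - snd k)
      in Hbt by (field; lra).
    lra.
  - assert (Hz' : In k (zero_part cs)) by (apply in_zero_part; auto).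
    specialize (Hw0 k (proj2 (in_fm_elim cs k) (or_introl Hz'))). rewrite Hz. lra.
  - assert (Hp : In k (pos_part cs)) by (apply in_pos_part; auto).
    specialize (Ht1 _ Hp). set (a := fst k x) in *.
    assert (Hat : a * ((snd k - lin xs (fst k) w0) / a) <= a * t) by (apply Rmult_le_compat_l; lra).
    replace (a * ((snd k - lin xs (fst k) w0) / a)) with (snd k - lin xs (fst k) w0)
      in Hat by (field; lra).
    lra.
Qed.

End Elimination.

Lemma approx_feasible_feasible (X : Type) (dec : forall a b : X, {a = b} + {a <> b})
  (vs : list X) (cs : list (constraint X)) :
  NoDup vs -> approx_feasible vs cs -> feasible vs cs.
Proof.
  revert cs. induction vs as [|x xs IH]; intros cs Hnd Happ.
  - exists (fun _ => 0). intros k Hk. simpl. apply Rnot_lt_le; intros Hlt.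
    destruct (Happ (snd k / 2)) as [w Hw]; [lra|]. specialize (Hw k Hk). simpl in Hw. lra.
  - inversion Hnd as [|? ? Hx Hnd']; subst.
    apply (fm_elim_feasible X dec x xs cs Hx), IH, fm_elim_approx_feasible; auto.
Qed.

(** * Slack of labelled inequations *)

Lemma sumv_perm (v : form -> nat -> R) (l l' : list lf) : Permutation l l' -> sumv v l = sumv v l'.
Proof. induction 1; simpl; try congruence; lra. Qed.

Lemma sumv_ext (v v' : form -> nat -> R) (l : list lf) :
  (forall x, In x l -> v (fst x) (snd x) = v' (fst x) (snd x)) -> sumv v l = sumv v' l.
Proof.
  induction l as [|x l IH]; intros H; auto. simpl. rewrite H, IH; simpl; auto.
  intros y Hy; apply H; simpl; auto.
Qed.

Definition slack (v : form -> nat -> R) (P : ineq) : R := sumv v (lhs P) - sumv v (rhs P).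

Lemma holds_slack (v : form -> nat -> R) (P : ineq) :
  holds v P <-> (if strict P then 0 < slack v P else 0 <= slack v P).
Proof. unfold holds, slack. destruct (strict P); split; intros; lra. Qed.

Lemma slack_perm (v : form -> nat -> R) (P P' : ineq) :
  Permutation (lhs P) (lhs P') -> Permutation (rhs P) (rhs P') -> slack v P = slack v P'.
Proof. intros Hl Hr. unfold slack. rewrite (sumv_perm v _ _ Hl), (sumv_perm v _ _ Hr). auto. Qed.

(* The propositional rules are invertible: the first half of each clause makes them sound,
   the second half lets a countermodel of the conclusions refute the premise. *)
Definition rule_slack (v : form -> nat -> R) (P : ineq) (a : alt) : Prop :=
  match a with
  | One cs => (forall c, In c cs -> strict c = strict P /\ slack v P <= slack v c) /\
              (exists c, In c cs /\ slack v c <= slack v P)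
  | Two c1 c2 => strict c1 = strict P /\ strict c2 = strict P /\
              (slack v P <= slack v c1 \/ slack v P <= slack v c2) /\
              slack v c1 <= slack v P /\ slack v c2 <= slack v P
  end.

Lemma In_lfs_perm (P P' : ineq) (x : lf) :
  Permutation (lhs P) (lhs P') -> Permutation (rhs P) (rhs P') ->
  In x (lhs P' ++ rhs P') -> In x (lhs P ++ rhs P).
Proof.
  intros Hl Hr Hx. rewrite in_app_iff in Hx |- *.
  destruct Hx; [left; eapply Permutation_in; [symmetry; eauto|auto]
               |right; eapply Permutation_in; [symmetry; eauto|auto]].
Qed.

Lemma prop_rule_slack (v : form -> nat -> R) (Q : form -> Prop)
  (HZ : forall i, Q Zero -> v Zero i = 0)
  (HA : forall a b i, Q (Amp a b) -> v (Amp a b) i = v a i + v b i)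
  (HI : forall a b i, Q (Imp a b) -> v (Imp a b) i = v b i - v a i)
  (HC : forall a b i, Q (Conj a b) -> v (Conj a b) i = Rmin (v a i) (v b i))
  (HD : forall a b i, Q (Disj a b) -> v (Disj a b) i = Rmax (v a i) (v b i))
  (P : ineq) (a : alt) :
  prop_app P a -> (forall x, In x (lhs P ++ rhs P) -> Q (fst x)) -> rule_slack v P a.
Proof.
  intros [P' [Hl [Hr [Hs Hrule]]]] HQ.
  assert (HQ' : forall x, In x (lhs P' ++ rhs P') -> Q (fst x))
    by (intros x Hx; apply HQ; eapply In_lfs_perm; eauto).
  unfold rule_slack. rewrite (slack_perm v P P' Hl Hr), Hs. clear Hl Hr HQ Hs.
  destruct Hrule; unfold slack in *; simpl in *;
    repeat match goal with
    | |- context [v (Amp ?a ?b) ?i] =>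
        rewrite (HA a b i) by (apply (HQ' (Amp a b, i)); simpl; rewrite ?in_app_iff; simpl; auto)
    | |- context [v (Imp ?a ?b) ?i] =>
        rewrite (HI a b i) by (apply (HQ' (Imp a b, i)); simpl; rewrite ?in_app_iff; simpl; auto)
    | |- context [v (Conj ?a ?b) ?i] =>
        rewrite (HC a b i) by (apply (HQ' (Conj a b, i)); simpl; rewrite ?in_app_iff; simpl; auto)
    | |- context [v (Disj ?a ?b) ?i] =>
        rewrite (HD a b i) by (apply (HQ' (Disj a b, i)); simpl; rewrite ?in_app_iff; simpl; auto)
    | |- context [v Zero ?i] =>
        rewrite (HZ i) by (apply (HQ' (Zero, i)); simpl; rewrite ?in_app_iff; simpl; auto)
    end;
    unfold Rmin, Rmax; try destruct (Rle_dec _ _);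
    repeat split; intros; simpl in *;
    repeat match goal with H : _ \/ _ |- _ => destruct H | H : False |- _ => contradiction end;
    subst; simpl; try reflexivity; try lra;
    try (eexists; split; [left; reflexivity|simpl; lra]);
    try (eexists; split; [right; left; reflexivity|simpl; lra]);
    try (left; lra); try (right; lra).
Qed.

(** * Soundness of LK(A) *)

Definition lf_dec (x y : lf) : {x = y} + {x <> y}.
Proof. decide equality; [apply PeanoNat.Nat.eq_dec|apply form_eq_dec]. Defined.

Definition occurrences (l : list lf) (y : lf) : R := INR (count_occ lf_dec l y).

Lemma sumv_lin (vs : list lf) (l : list lf) (w : lf -> R) : NoDup vs -> incl l vs ->
  sumv (fun f i => w (f, i)) l = lin vs (occurrences l) w.
Proof.
  intros Hnd. induction l as [|x l IH]; intros Hinc.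
  - unfold occurrences; simpl. rewrite lin_zero. reflexivity.
  - simpl. rewrite IH by (intros z Hz; apply Hinc; simpl; auto).
    rewrite (lin_ext vs (occurrences (x :: l))
               (fun y => 1 * (if lf_dec x y then 1 else 0) + 1 * occurrences l y) w w).
    + rewrite lin_comb, (lin_indicator lf_dec) by (auto; apply Hinc; simpl; auto).
      destruct x; simpl. ring.
    + intros y _. unfold occurrences; simpl. destruct (lf_dec x y); rewrite ?S_INR; ring.
Qed.

Definition atomLKb (f : form) : bool := match f with Var _ | Box _ => true | _ => false end.

Lemma fresh_node j B n : fresh j B -> In n B -> ~ In j (node_labels n).
Proof. intros Hf Hn Hj. apply Hf. apply in_flat_map. eauto. Qed.

Lemma fresh_lf j B P x : fresh j B -> In (NI P) B -> In x (lhs P ++ rhs P) -> snd x <> j.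
Proof.
  intros Hf Hn Hx Heq. apply (fresh_node j B (NI P) Hf Hn). simpl. rewrite <- Heq.
  apply in_map; auto.
Qed.

Definition upd {A : Type} (g : nat -> A) (j : nat) (y : A) : nat -> A :=
  fun l => if PeanoNat.Nat.eq_dec l j then y else g l.

Lemma upd_eq {A : Type} (g : nat -> A) j y : upd g j y j = y.
Proof. unfold upd. destruct (PeanoNat.Nat.eq_dec j j); tauto. Qed.

Lemma upd_neq {A : Type} (g : nat -> A) j y l : l <> j -> upd g j y l = g l.
Proof. unfold upd. destruct (PeanoNat.Nat.eq_dec l j); tauto. Qed.

Section Soundness.

Variables (W : Type) (Rel : W -> W -> Prop) (V : nat -> W -> R).

Definition label_val (g : nat -> W) : form -> nat -> R := fun f i => eval Rel V f (g i).

Lemma label_val_rule_slack g P a : prop_app P a -> rule_slack (label_val g) P a.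
Proof. intros H. apply (prop_rule_slack _ (fun _ => True)); auto. Qed.

Definition realizes (delta eps : R) (g : nat -> W) (B : list node) : Prop :=
  (forall i j, In (NR i j) B -> Rel (g i) (g j)) /\
  (forall P, In (NI P) B -> if strict P then delta <= slack (label_val g) P
                           else - eps <= slack (label_val g) P).

Definition approx_realizable (delta : R) (B : list node) : Prop :=
  forall eps, 0 < eps -> exists g, realizes delta eps g B.

Lemma realizes_app delta eps g B B' :
  realizes delta eps g B -> realizes delta eps g B' -> realizes delta eps g (B ++ B').
Proof.
  intros [H1 H2] [H1' H2']. split.
  - intros i j H. apply in_app_iff in H. destruct H; [apply H1|apply H1']; auto.
  - intros P H. apply in_app_iff in H. destruct H; [apply H2|apply H2']; auto.
Qed.

Lemma realizes_mono delta e e' g B :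
  e <= e' -> realizes delta e g B -> realizes delta e' g B.
Proof.
  intros He [H1 H2]. split; auto. intros P HP. specialize (H2 P HP). destruct (strict P); lra.
Qed.

Lemma realizes_ineq delta eps g P :
  (if strict P then delta <= slack (label_val g) P else - eps <= slack (label_val g) P) ->
  realizes delta eps g [NI P].
Proof.
  intros H. split; [intros i j [E|[]]; discriminate|]. intros Q [E|[]]. injection E as ->. auto.
Qed.

(* The atoms of the system are the unknowns of a linear system of which approximate
   realizations are approximate solutions. *)
Lemma approx_realizable_sat delta B :
  0 < delta -> approx_realizable delta B -> sat_sys atomLK (ineqs_of B).
Proof.
  intros Hd Hr.
  set (As := filter (fun P => forallb (fun x => atomLKb (fst x)) (lhs P ++ rhs P)) (ineqs_of B)).
  set (vs := nodup lf_dec (flat_map (fun P => lhs P ++ rhs P) As)).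
  assert (Hnd : NoDup vs) by apply NoDup_nodup.
  assert (Hinc : forall P, In P As -> incl (lhs P) vs /\ incl (rhs P) vs).
  { intros P HP. split; intros x Hx; apply nodup_In; apply in_flat_map; exists P;
      split; auto; apply in_app_iff; auto. }
  set (coeffs := fun P y => 1 * occurrences (lhs P) y + (-1) * occurrences (rhs P) y).
  assert (Hslack : forall (w : lf -> R) P, In P As ->
     slack (fun f i => w (f, i)) P = lin vs (coeffs P) w).
  { intros w P HP. unfold coeffs. rewrite lin_comb. unfold slack.
    destruct (Hinc P HP) as [H1 H2].
    rewrite <- (sumv_lin vs (lhs P)), <- (sumv_lin vs (rhs P)) by auto. ring. }
  assert (HAs : forall P, In P As -> In (NI P) B).
  { intros P HP. apply filter_In in HP. destruct HP as [HP _].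
    apply in_flat_map in HP. destruct HP as [[Q|] [HQ HPQ]]; simpl in HPQ;
      [destruct HPQ as [<-|[]]; auto|destruct HPQ]. }
  destruct (approx_feasible_feasible lf lf_dec vs
              (map (fun P => (coeffs P, if strict P then delta else 0)) As) Hnd) as [w Hw].
  - intros eps He. destruct (Hr eps He) as [g [_ Hg]].
    exists (fun x => label_val g (fst x) (snd x)). intros k Hk.
    apply in_map_iff in Hk. destruct Hk as [P [<- HP]]. simpl.
    rewrite <- Hslack by auto. simpl.
    change (fun (f : form) (i : nat) => label_val g f i) with (label_val g).
    specialize (Hg P (HAs P HP)). destruct (strict P); lra.
  - exists (fun f i => w (f, i)). intros P HP Hat.
    assert (HPA : In P As).
    { apply filter_In. split; auto. apply forallb_forall.
      intros x Hx. specialize (Hat x Hx). destruct x as [[] ?]; simpl in *; auto. }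
    specialize (Hw _ (in_map _ _ _ HPA)). simpl in Hw.
    rewrite <- Hslack in Hw by auto.
    apply holds_slack. destruct (strict P); lra.
Qed.

Lemma realizes_upd delta eps B g j y :
  fresh j B -> realizes delta eps g B -> realizes delta eps (upd g j y) B.
Proof.
  intros Hf [H1 H2]. split.
  - intros a b Hab. pose proof (fresh_node j B _ Hf Hab) as Hn. simpl in Hn.
    rewrite !upd_neq by tauto. auto.
  - intros P HP. specialize (H2 P HP).
    replace (slack (label_val (upd g j y)) P) with (slack (label_val g) P); auto.
    unfold slack. f_equal; apply sumv_ext; intros x Hx; unfold label_val;
      rewrite upd_neq; auto; apply (fresh_lf j B P x Hf HP); apply in_app_iff; auto.
Qed.

Lemma realizes_prop_one delta eps g B P cs : realizes delta eps g B -> In (NI P) B ->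
  prop_app P (One cs) -> realizes delta eps g (map NI cs).
Proof.
  intros [Hg1 Hg2] HP Happ. split.
  - intros a b Hab. apply in_map_iff in Hab. destruct Hab as [? [? _]]; discriminate.
  - intros Q HQ. apply in_map_iff in HQ. destruct HQ as [c [Hc HQ]]. injection Hc as <-.
    destruct (label_val_rule_slack g P _ Happ) as [Hs _].
    destruct (Hs c HQ) as [Hst Hle]. specialize (Hg2 P HP). rewrite Hst.
    destruct (strict P); lra.
Qed.

Lemma realizes_prop_two delta eps g B P c1 c2 : realizes delta eps g B -> In (NI P) B ->
  prop_app P (Two c1 c2) -> realizes delta eps g [NI c1] \/ realizes delta eps g [NI c2].
Proof.
  intros [_ Hg] HP Happ. specialize (Hg P HP).
  destruct (label_val_rule_slack g P _ Happ) as [Hs1 [Hs2 [Hor _]]].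
  destruct Hor; [left|right]; apply realizes_ineq;
    [rewrite Hs1|rewrite Hs2]; destruct (strict P); lra.
Qed.

Section BoundedSerial.

Variable r : R.
Hypothesis r_ge0 : 0 <= r.
Hypothesis V_bounded : forall p x, Rabs (V p x) <= r.
Hypothesis Rel_serial : forall x, exists y, Rel x y.

Lemma realizes_box_l delta eps g phi i j : 0 < eps -> Rel (g i) (g j) ->
  realizes delta eps g [NI (mkI [(phi, j)] false [(Box phi, i)])].
Proof.
  intros He HR. apply realizes_ineq. simpl.
  unfold slack, sumv, label_val; cbn [lhs rhs fold_right fst snd].
  pose proof (eval_Box_le W Rel V r r_ge0 V_bounded phi (g i) (g j) HR). lra.
Qed.

(* The infimum need not be attained: the new world is [eps]-optimal. *)
Lemma realizes_box_r delta eps g phi i j : i <> j -> 0 < eps -> exists y,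
  realizes delta eps (upd g j y) [NI (mkI [(Box phi, i)] false [(phi, j)]); NR i j].
Proof.
  intros Hij He.
  destruct (eval_Box_approx W Rel V r r_ge0 V_bounded phi (g i) eps (Rel_serial (g i)) He)
    as [y [Hy1 Hy2]].
  exists y. split.
  - intros a b [E|[E|[]]]; [discriminate|]. injection E as <- <-. rewrite upd_eq, upd_neq; auto.
  - intros Q [E|[E|[]]]; [|discriminate]. injection E as <-. simpl.
    unfold slack, sumv, label_val; cbn [lhs rhs fold_right fst snd]. rewrite upd_eq, upd_neq; auto.
    lra.
Qed.

Lemma lk_closed_not_approx_realizable delta B :
  0 < delta -> lk_closed B -> ~ approx_realizable delta B.
Proof.
  intros Hd Hcl. induction Hcl as
    [B Hu|B P cs HP Happ Hcl IH|B P c1 c2 HP Happ Hcl1 IH1 Hcl2 IH2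
    |B P phi i j HR HP Hin Hcl IH|B P phi i j HP Hin Hf Hcl IH|B i k j HR Hf Hcl IH];
    intros Hre.
  - exact (Hu (approx_realizable_sat delta B Hd Hre)).
  - apply IH. intros eps He. destruct (Hre eps He) as [g Hg]. exists g.
    apply realizes_app; [|eapply realizes_prop_one]; eauto.
  - (* one alternative is realized up to every [eps], by taking the smaller of two failures *)
    apply not_all_ex_not in IH1, IH2. destruct IH1 as [e1 IH1], IH2 as [e2 IH2].
    apply imply_to_and in IH1, IH2. destruct IH1 as [He1 IH1], IH2 as [He2 IH2].
    destruct (Hre (Rmin e1 e2) (Rmin_glb_lt _ _ _ He1 He2)) as [g Hg].
    pose proof (Rmin_l e1 e2). pose proof (Rmin_r e1 e2).
    destruct (realizes_prop_two _ _ g B P c1 c2 Hg HP Happ) as [Hc|Hc];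
      [apply IH1|apply IH2]; exists g; apply realizes_app; eapply realizes_mono; eauto.
  - apply IH. intros eps He. destruct (Hre eps He) as [g Hg]. exists g.
    apply realizes_app; auto. apply realizes_box_l; [exact He|exact (proj1 Hg i j HR)].
  - apply IH. intros eps He. destruct (Hre eps He) as [g Hg].
    assert (Hij : i <> j).
    { intros ->. apply (fresh_lf j B P (Box phi, j) Hf HP); auto. apply in_app_iff; auto. }
    destruct (realizes_box_r delta eps g phi i j Hij He) as [y Hy].
    exists (upd g j y). apply realizes_app; [apply realizes_upd|]; auto.
  - apply IH. intros eps He. destruct (Hre eps He) as [g Hg].
    destruct (Rel_serial (g k)) as [y Hy].
    assert (Hkj : k <> j) by (intros ->; apply (fresh_node j B _ Hf HR); simpl; auto).
    exists (upd g j y). apply realizes_app; [apply realizes_upd; auto|]. split.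
    + intros a b [E|[]]. injection E as <- <-. rewrite upd_eq, upd_neq; auto.
    + intros Q [E|[]]. discriminate.
Qed.

End BoundedSerial.

End Soundness.

Theorem LK_derivable_valid (phi : form) : LKA_derivable phi -> KA_valid phi.
Proof.
  intros Hd W Rel V r hr hV x.
  apply Rnot_lt_le. intros Hlt.
  destruct (serial_rel_serial W Rel (Some x)) as [y Hy].
  apply (lk_closed_not_approx_realizable _ (serial_rel Rel) (serial_val V) r hr
           (serial_val_bounded W V r hr hV) (serial_rel_serial W Rel)
           (- eval Rel V phi x) _ ltac:(lra) Hd).
  intros eps He. exists (fun l => if PeanoNat.Nat.eq_dec l 2 then y else Some x). split.
  - intros a b [H|[H|[]]]; [discriminate|]. injection H as <- <-. exact Hy.
  - intros P [H|[H|[]]]; [|discriminate]. injection H as <-. simpl.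
    unfold slack, sumv, label_val; simpl. rewrite (proj1 (eval_serial W Rel V phi)). lra.
Qed.

(** * From complete LK'(A)-tableaux to LK(A)-tableaux *)

Definition immediate_sub (a f : form) : Prop :=
  match f with
  | Conj b c | Disj b c | Amp b c | Imp b c => a = b \/ a = c
  | _ => False
  end.

Definition alt_concls (a : alt) : list ineq :=
  match a with One cs => cs | Two c1 c2 => [c1; c2] end.

Lemma prop_app_lfs P a : prop_app P a -> forall c, In c (alt_concls a) ->
  forall x, In x (lhs c ++ rhs c) ->
  exists y, In y (lhs P ++ rhs P) /\ snd y = snd x /\ (x = y \/ immediate_sub (fst x) (fst y)).
Proof.
  intros [P' [Hl [Hr [_ Hrule]]]] c Hc x Hx.
  enough (exists y, In y (lhs P' ++ rhs P') /\ snd y = snd x /\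
                    (x = y \/ immediate_sub (fst x) (fst y))) as [y [Hy1 Hy2]]
    by (exists y; split; [eapply In_lfs_perm|]; eauto).
  destruct Hrule; simpl in Hc;
    repeat match goal with H : _ \/ _ |- _ => destruct H | H : False |- _ => contradiction end;
    subst; simpl in *; rewrite ?in_app_iff in *; simpl in *;
    repeat match goal with H : _ \/ _ |- _ => destruct H end; subst;
    try solve [eexists; split; [rewrite ?in_app_iff; simpl; eauto 6|split; [reflexivity|auto]]];
    try solve [eexists; split; [rewrite ?in_app_iff; simpl; left; left; reflexivity|simpl; auto]];
    try solve [eexists; split; [rewrite ?in_app_iff; simpl; right; left; reflexivity|simpl; auto]];
    try solve [eexists; split; [rewrite ?in_app_iff; simpl; left; reflexivity|simpl; auto]];
    try solve [exists x; split; [apply in_app_iff; simpl; tauto|auto]];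
    try solve [eexists; split; [apply in_app_iff; simpl; right; left; reflexivity|simpl; auto]].
Qed.

Fixpoint unbracket (f : form) : form :=
  match f with
  | Var p => Var p
  | BVar a => Box (unbracket a)
  | Zero => Zero
  | Conj a b => Conj (unbracket a) (unbracket b)
  | Disj a b => Disj (unbracket a) (unbracket b)
  | Amp a b => Amp (unbracket a) (unbracket b)
  | Imp a b => Imp (unbracket a) (unbracket b)
  | Box a => Box (unbracket a)
  end.

Lemma unbracket_pure f : pure f -> unbracket f = f.
Proof. induction f; simpl; intros; try tauto; f_equal; tauto. Qed.

Definition map_lf (rho : nat -> nat) (x : lf) : lf := (unbracket (fst x), rho (snd x)).
Definition map_ineq (rho : nat -> nat) (P : ineq) : ineq :=
  mkI (map (map_lf rho) (lhs P)) (strict P) (map (map_lf rho) (rhs P)).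
Definition map_node (rho : nat -> nat) (n : node) : node :=
  match n with NI P => NI (map_ineq rho P) | NR i j => NR (rho i) (rho j) end.
Definition map_alt (rho : nat -> nat) (a : alt) : alt :=
  match a with
  | One cs => One (map (map_ineq rho) cs)
  | Two c1 c2 => Two (map_ineq rho c1) (map_ineq rho c2)
  end.

Lemma prop_app_map rho P a : prop_app P a -> prop_app (map_ineq rho P) (map_alt rho a).
Proof.
  intros [P' [Hl [Hr [Hs Hrule]]]]. exists (map_ineq rho P').
  repeat split; try apply Permutation_map; auto.
  destruct Hrule; simpl; constructor.
Qed.

Lemma sumv_map_lf rho v l :
  sumv v (map (map_lf rho) l) = sumv (fun f i => v (unbracket f) (rho i)) l.
Proof. induction l; simpl; auto. unfold sumv in *; simpl. rewrite IHl. reflexivity. Qed.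

Lemma lf_eqb_true x y : lf_eqb x y = true <-> x = y.
Proof.
  unfold lf_eqb. destruct x as [f i], y as [g j]; simpl.
  destruct (form_eq_dec f g) as [->|Hne].
  - rewrite PeanoNat.Nat.eqb_eq. split; [intros ->|intros H; injection H]; auto.
  - split; [discriminate|intros H; injection H; intros; contradiction].
Qed.

Lemma map_lf_repl rho psi i l : map (map_lf rho) (repl psi i l) = map (map_lf rho) l.
Proof.
  unfold repl. rewrite map_map. apply map_ext. intros x.
  destruct (lf_eqb x (Box psi, i)) eqn:E; auto. apply lf_eqb_true in E. subst. reflexivity.
Qed.

Lemma map_node_upd rho j j' n :
  ~ In j (node_labels n) -> map_node (upd rho j j') n = map_node rho n.
Proof.
  intros Hn. destruct n as [P|a c]; simpl in *.
  - unfold map_ineq. f_equal. f_equal; apply map_ext_in; intros x Hx; unfold map_lf;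
      rewrite upd_neq; auto; intros E; apply Hn; rewrite <- E;
      apply in_map; apply in_app_iff; auto.
  - rewrite !upd_neq; tauto.
Qed.

(* (ex) needs an existing relation at the label where it is applied: in an LK(A)-tableau
   every label occurs in some relation. *)
Definition labels_related (B : list node) : Prop :=
  forall l, In l (flat_map node_labels B) -> exists m, In (NR l m) B \/ In (NR m l) B.

Definition simulated_by (rho : nat -> nat) (b : branch) (B : list node) : Prop :=
  (forall n, In n (bnodes b) -> In (map_node rho n) B) /\ labels_related B.

Lemma fresh_exists (B : list node) : exists j, fresh j B.
Proof.
  assert (forall l : list nat, exists j, forall x, In x l -> (x < j)%nat) as H.
  { induction l as [|a l [j Hj]]; [exists 0%nat; intros ? []|].
    exists (S (Nat.max a j)). intros x [<-|Hx]; [lia|]. specialize (Hj x Hx). lia. }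
  destruct (H (flat_map node_labels B)) as [j Hj]. exists j. intros Hin. specialize (Hj j Hin). lia.
Qed.

Lemma bnodes_app b1 b2 : bnodes (b1 ++ b2) = bnodes b1 ++ bnodes b2.
Proof. apply map_app. Qed.

Lemma bnodes_deact h b : bnodes (deact h b) = bnodes b.
Proof.
  unfold bnodes, deact. rewrite map_map. apply map_ext. intros m. destruct (h m); reflexivity.
Qed.

Lemma in_bnodes n b : In n (bnodes b) <-> exists m, In (n, m) b.
Proof.
  unfold bnodes. rewrite in_map_iff. split.
  - intros [[n' m] [Hn Hin]]; simpl in Hn; subst; eauto.
  - intros [m Hm]; exists (n, m); auto.
Qed.

Lemma in_bnodes_app n b1 b2 : In n (bnodes (b1 ++ b2)) <-> In n (bnodes b1) \/ In n (bnodes b2).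
Proof. rewrite bnodes_app, in_app_iff. tauto. Qed.

Lemma in_bnodes_act n cs : In n (bnodes (map act cs)) <-> exists c, In c cs /\ n = NI c.
Proof.
  unfold bnodes, act. rewrite map_map, in_map_iff. simpl. split.
  - intros [c [<- Hc]]; eauto.
  - intros [c [Hc ->]]; eauto.
Qed.

Lemma simulated_unsat rho b B : simulated_by rho b B -> sat_sys atomLK (ineqs_of B) ->
  sat_sys atomLK' (ineqs_of (bnodes b)).
Proof.
  intros [HS _] [v Hv]. exists (fun f i => v (unbracket f) (rho i)). intros P HP Hat.
  assert (HB : In (map_ineq rho P) (ineqs_of B)).
  { apply in_flat_map in HP. destruct HP as [[Q|] [HQ HPQ]]; simpl in HPQ; [|contradiction].
    destruct HPQ as [->|[]].
    apply in_flat_map. exists (NI (map_ineq rho P)). split; [apply (HS (NI P)); auto|simpl; auto]. }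
  specialize (Hv _ HB). unfold holds in *. simpl in Hv. rewrite !sumv_map_lf in Hv. apply Hv.
  intros x Hx. simpl in Hx. rewrite <- map_app in Hx. apply in_map_iff in Hx.
  destruct Hx as [y [<- Hy]]. specialize (Hat y Hy). destruct y as [[] ?]; simpl in *; auto.
Qed.

Lemma labels_related_app B extra : labels_related B ->
  (forall l, In l (flat_map node_labels extra) ->
     exists m, In (NR l m) (B ++ extra) \/ In (NR m l) (B ++ extra)) ->
  labels_related (B ++ extra).
Proof.
  intros HL He l Hl. rewrite flat_map_app in Hl. apply in_app_iff in Hl.
  destruct Hl as [Hl|Hl]; auto.
  destruct (HL l Hl) as [m Hm]. exists m. rewrite !in_app_iff. tauto.
Qed.

Lemma labels_related_old_labels B extra :
  labels_related B -> incl (flat_map node_labels extra) (flat_map node_labels B) ->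
  labels_related (B ++ extra).
Proof.
  intros HL Hinc. apply labels_related_app; auto. intros l Hl.
  destruct (HL l (Hinc l Hl)) as [m Hm]. exists m. rewrite !in_app_iff. tauto.
Qed.

Lemma labels_related_new_edge B extra i j : labels_related B -> In (NR i j) extra ->
  (forall l, In l (flat_map node_labels extra) -> l = i \/ l = j) ->
  labels_related (B ++ extra).
Proof.
  intros HL Hij Hl. apply labels_related_app; auto. intros l Hin.
  exists (if PeanoNat.Nat.eq_dec l i then j else i). rewrite !in_app_iff.
  destruct (Hl l Hin) as [->| ->]; destruct (PeanoNat.Nat.eq_dec _ i); subst; tauto.
Qed.

Lemma labels_related_prop B P a cs : labels_related B -> In (NI P) B -> prop_app P a ->
  incl cs (alt_concls a) -> labels_related (B ++ map NI cs).
Proof.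
  intros HL HP Ha Hcs. apply labels_related_old_labels; auto. intros l Hl.
  apply in_flat_map in Hl. destruct Hl as [n [Hn Hl]]. apply in_map_iff in Hn.
  destruct Hn as [c [<- Hc]]. simpl in Hl. apply in_map_iff in Hl. destruct Hl as [x [<- Hx]].
  destruct (prop_app_lfs P a Ha c (Hcs c Hc) x Hx) as [y [Hy [Hyx _]]].
  apply in_flat_map. exists (NI P). split; auto. simpl. rewrite <- Hyx. apply in_map; auto.
Qed.

Definition lk_closable (b : branch) : Prop :=
  forall rho B, simulated_by rho b B -> lk_closed B.

Lemma simulated_pstep rho b1 b2 P a cs B :
  simulated_by rho (b1 ++ (NI P, true) :: b2) B -> prop_app P a -> incl cs (alt_concls a) ->
  simulated_by rho (b1 ++ (NI P, false) :: b2 ++ map act cs)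
    (B ++ map NI (map (map_ineq rho) cs)).
Proof.
  intros [HS HL] Ha Hcs.
  assert (HPB : In (NI (map_ineq rho P)) B)
    by (apply (HS (NI P)); rewrite in_bnodes_app; simpl; auto).
  split.
  - intros n Hn. rewrite in_app_iff.
    rewrite in_bnodes_app in Hn. simpl in Hn. rewrite in_bnodes_app, in_bnodes_act in Hn.
    destruct Hn as [Hn|[<-|[Hn|[c [Hc ->]]]]].
    + left; apply HS; rewrite in_bnodes_app; auto.
    + left; auto.
    + left; apply HS; rewrite in_bnodes_app; simpl; auto.
    + right. rewrite map_map. apply in_map_iff. exists c; auto.
  - apply (labels_related_prop B _ _ _ HL HPB (prop_app_map rho P _ Ha)).
    intros c Hc. apply in_map_iff in Hc. destruct Hc as [c' [<- Hc']].
    specialize (Hcs c' Hc'). destruct a; simpl in *; [apply in_map; auto|].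
    intuition (subst; auto).
Qed.

Lemma lk_closable_pstep b bs : pstep b bs -> (forall b', In b' bs -> lk_closable b') ->
  lk_closable b.
Proof.
  intros Hp Hg rho B HSim. pose proof (proj1 HSim) as HS.
  destruct Hp as [b1 b2 P cs Ha|b1 b2 P c1 c2 Ha];
    (assert (HPB : In (NI (map_ineq rho P)) B)
       by (apply (HS (NI P)); rewrite in_bnodes_app; simpl; auto)).
  - apply (lk_prop1 B _ _ HPB (prop_app_map rho P _ Ha)).
    apply (Hg _ (or_introl eq_refl) rho).
    apply (simulated_pstep rho b1 b2 P _ cs B HSim Ha). intros c; auto.
  - apply (lk_prop2 B _ _ _ HPB (prop_app_map rho P _ Ha)).
    + apply (Hg _ (or_introl eq_refl) rho).
      apply (simulated_pstep rho b1 b2 P _ [c1] B HSim Ha). intros c [<-|[]]; simpl; auto.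
    + apply (Hg _ (or_intror (or_introl eq_refl)) rho).
      apply (simulated_pstep rho b1 b2 P _ [c2] B HSim Ha). intros c [<-|[]]; simpl; auto.
Qed.

Lemma hasL_true psi i m : hasL psi i m = true ->
  exists P, m = (NI P, true) /\ In (Box psi, i) (lhs P).
Proof.
  destruct m as [[P|] [|]]; simpl; try discriminate.
  intros H. apply existsb_exists in H. destruct H as [x [Hx Heq]].
  apply lf_eqb_true in Heq. subst. eauto.
Qed.

Lemma hasR_true psi i m : hasR psi i m = true ->
  exists P, m = (NI P, true) /\ In (Box psi, i) (rhs P).
Proof.
  destruct m as [[P|] [|]]; simpl; try discriminate.
  intros H. apply existsb_exists in H. destruct H as [x [Hx Heq]].
  apply lf_eqb_true in Heq. subst. eauto.
Qed.

Lemma existsb_hasL psi i b : existsb (hasL psi i) b = true <->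
  exists P, In (NI P, true) b /\ In (Box psi, i) (lhs P).
Proof.
  rewrite existsb_exists. split.
  - intros [m [Hm H]]. apply hasL_true in H. destruct H as [P [-> HP]]. eauto.
  - intros [P [HP Hx]]. exists (NI P, true). split; auto. simpl. apply existsb_exists.
    exists (Box psi, i). split; auto. apply lf_eqb_true; auto.
Qed.

Lemma existsb_hasR psi i b : existsb (hasR psi i) b = true <->
  exists P, In (NI P, true) b /\ In (Box psi, i) (rhs P).
Proof.
  rewrite existsb_exists. split.
  - intros [m [Hm H]]. apply hasR_true in H. destruct H as [P [-> HP]]. eauto.
  - intros [P [HP Hx]]. exists (NI P, true). split; auto. simpl. apply existsb_exists.
    exists (Box psi, i). split; auto. apply lf_eqb_true; auto.
Qed.

Lemma in_succs i j b : In j (succs i b) <-> exists m, In (NR i j, m) b.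
Proof.
  unfold succs. rewrite in_flat_map. split.
  - intros [[n m] [Hn Hj]]. simpl in Hj. destruct n as [P|i' j']; [destruct Hj|].
    destruct (PeanoNat.Nat.eqb_spec i i') as [<-|]; [|destruct Hj].
    destruct Hj as [<-|[]]. eauto.
  - intros [m Hm]. exists (NR i j, m). split; auto. simpl. rewrite PeanoNat.Nat.eqb_refl.
    simpl; auto.
Qed.

Lemma in_concl6 psi i b m : In m (concl6 psi i b) ->
  exists P, In (NI P, true) b /\ In (Box psi, i) (lhs P) /\
            m = act (mkI (repl psi i (lhs P)) (strict P) (rhs P)).
Proof.
  unfold concl6. rewrite in_flat_map. intros [m' [Hm' Hm]].
  destruct (hasL psi i m') eqn:E; [|destruct Hm].
  apply hasL_true in E. destruct E as [P [-> HP]]. simpl in Hm.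
  destruct Hm as [<-|[]]. eauto.
Qed.

Lemma in_concl5 psi i b m : In m (concl5 psi i b) ->
  exists P, In (NI P, true) b /\ In (Box psi, i) (rhs P) /\
            m = act (mkI (lhs P) (strict P) (repl psi i (rhs P))).
Proof.
  unfold concl5. rewrite in_flat_map. intros [m' [Hm' Hm]].
  destruct (hasR psi i m') eqn:E; [|destruct Hm].
  apply hasR_true in E. destruct E as [P [-> HP]]. simpl in Hm.
  destruct Hm as [<-|[]]. eauto.
Qed.

Lemma lk_closed_box_l_all (rho : nat -> nat) ri phi Q js B :
  (forall j, In j js -> In (NR ri (rho j)) B) -> In (NI Q) B -> In (Box phi, ri) (lhs Q) ->
  lk_closed (B ++ map (fun j => NI (mkI [(phi, rho j)] false [(Box phi, ri)])) js) ->
  lk_closed B.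
Proof.
  revert B. induction js as [|j js IH]; intros B HR HQ Hb Hc.
  - rewrite app_nil_r in Hc; auto.
  - apply (lk_box_l B Q phi ri (rho j)); auto; [apply HR; simpl; auto|].
    apply IH; auto.
    + intros j' Hj'. apply in_app_iff. left. apply HR. simpl; auto.
    + apply in_app_iff; auto.
    + rewrite <- app_assoc. exact Hc.
Qed.

Lemma map_node_labels rho B P x : In (NI (map_ineq rho P)) B -> In x (lhs P ++ rhs P) ->
  In (rho (snd x)) (flat_map node_labels B).
Proof.
  intros HB Hx. apply in_flat_map. exists (NI (map_ineq rho P)). split; auto. simpl.
  rewrite <- map_app, map_map. apply in_map_iff. exists x. split; auto.
Qed.

Lemma bfresh_node j b n m : bfresh j b -> In (n, m) b -> ~ In j (node_labels n).
Proof. intros Hf Hin. apply (fresh_node j (bnodes b) n Hf). apply in_bnodes. eauto. Qed.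

Lemma bfresh_lf j b P m x : bfresh j b -> In (NI P, m) b -> In x (lhs P ++ rhs P) -> snd x <> j.
Proof.
  intros Hf Hin Hx E. apply (bfresh_node j b (NI P) m Hf Hin). simpl. rewrite <- E.
  apply in_map; auto.
Qed.

Lemma simulated_old_nodes rho j j' b B n :
  bfresh j b -> (forall n, In n (bnodes b) -> In (map_node rho n) B) ->
  In n (bnodes b) -> In (map_node (upd rho j j') n) B.
Proof.
  intros Hf HS Hn. apply in_bnodes in Hn. destruct Hn as [m Hm].
  rewrite map_node_upd by (eapply bfresh_node; eauto). apply HS. apply in_bnodes; eauto.
Qed.

(* (□▷') becomes one application of (□▷) per successor of [i]. *)
Lemma lk_closable_step6_one i b b' : step6_one i b b' -> lk_closable b' -> lk_closable b.
Proof.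
  intros [psi [Hex ->]] Hg rho B [HS HL].
  destruct (proj1 (existsb_hasL psi i b) Hex) as [P [HPin HPb]].
  assert (HPB : In (NI (map_ineq rho P)) B) by (apply (HS (NI P)); apply in_bnodes; eauto).
  assert (HR : forall j, In j (succs i b) -> In (NR (rho i) (rho j)) B).
  { intros j Hj. apply in_succs in Hj. destruct Hj as [m Hm].
    apply (HS (NR i j)). apply in_bnodes; eauto. }
  apply (lk_closed_box_l_all rho (rho i) (unbracket psi) (map_ineq rho P) (succs i b) B); auto.
  { simpl. change (Box (unbracket psi), rho i) with (map_lf rho (Box psi, i)). apply in_map; auto. }
  apply (Hg rho). split.
  - intros n Hn. rewrite in_app_iff.
    rewrite !in_bnodes_app, bnodes_deact in Hn. destruct Hn as [Hn|[Hn|Hn]].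
    + left; auto.
    + apply in_bnodes in Hn. destruct Hn as [mk Hmk]. apply in_concl6 in Hmk.
      destruct Hmk as [Q [HQ [_ Heq]]]. injection Heq as -> _.
      left. simpl. unfold map_ineq; simpl. rewrite map_lf_repl.
      apply (HS (NI Q)). apply in_bnodes; eauto.
    + right. apply in_bnodes in Hn. destruct Hn as [mk Hmk].
      apply in_map_iff in Hmk. destruct Hmk as [j [Hj Hjs]]. injection Hj as <- _.
      apply in_map_iff. exists j. split; auto.
  - apply labels_related_old_labels; auto. intros l Hl.
    apply in_flat_map in Hl. destruct Hl as [n [Hn Hl]]. apply in_map_iff in Hn.
    destruct Hn as [j [<- Hj]]. apply in_flat_map. exists (NR (rho i) (rho j)).
    split; [apply HR; auto|]. simpl in Hl |- *. tauto.
Qed.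

(* (▷□') is (▷□) with the new label renamed to a label fresh for the LK-branch. *)
Lemma lk_closable_step5_one i b b' : step5_one i b b' -> lk_closable b' -> lk_closable b.
Proof.
  intros [psi [j [Hex [Hf ->]]]] Hg rho B [HS HL].
  destruct (proj1 (existsb_hasR psi i b) Hex) as [P [HPin HPb]].
  assert (HPB : In (NI (map_ineq rho P)) B) by (apply (HS (NI P)); apply in_bnodes; eauto).
  assert (Hij : i <> j)
    by (intros ->; apply (bfresh_lf j b P true (Box psi, j) Hf HPin); auto; apply in_app_iff; auto).
  destruct (fresh_exists B) as [jB HjB].
  apply (lk_box_r B (map_ineq rho P) (unbracket psi) (rho i) jB); auto.
  { simpl. change (Box (unbracket psi), rho i) with (map_lf rho (Box psi, i)). apply in_map; auto. }
  apply (Hg (upd rho j jB)). split.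
  - intros n Hn. rewrite in_app_iff.
    rewrite !in_bnodes_app, bnodes_deact in Hn. simpl in Hn.
    destruct Hn as [Hn|[Hn|[<-|[<-|[]]]]].
    + left. apply (simulated_old_nodes rho j jB b); auto.
    + left. apply in_bnodes in Hn. destruct Hn as [mk Hmk]. apply in_concl5 in Hmk.
      destruct Hmk as [Q [HQ [_ Heq]]]. injection Heq as -> _.
      replace (map_node (upd rho j jB) (NI (mkI (lhs Q) (strict Q) (repl psi i (rhs Q)))))
        with (map_node (upd rho j jB) (NI Q))
        by (simpl; unfold map_ineq; simpl; rewrite map_lf_repl; reflexivity).
      apply (simulated_old_nodes rho j jB b); auto. apply in_bnodes; eauto.
    + right. left. cbn [map_node]. unfold map_ineq, map_lf.
      cbn [map fst snd lhs rhs strict unbracket].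
      rewrite upd_eq, upd_neq; auto.
    + right. right. left. cbn [map_node]. rewrite upd_eq, upd_neq; auto.
  - apply (labels_related_new_edge _ _ (rho i) jB HL); [simpl; auto|].
    intros l Hl. simpl in Hl. destruct Hl as [<-|[<-|[<-|[<-|[]]]]]; auto.
Qed.

(* (ex) supplies the new successor of [i], unless the LK-branch already has one. *)
Lemma lk_closable_step4 i b b4 : step4 i b b4 -> lk_closable b4 -> lk_closable b.
Proof.
  intros [[Hbox [k [Hf ->]]]|[_ ->]] Hg; auto.
  intros rho B [HS HL].
  destruct Hbox as [P [psi [HPin Hx]]].
  assert (HPB : In (NI (map_ineq rho P)) B) by (apply (HS (NI P)); apply in_bnodes; eauto).
  assert (Hik : i <> k) by (intros ->; apply (bfresh_lf k b P true (Box psi, k) Hf HPin); auto).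
  assert (Hold : forall k', forall n, In n (bnodes b) -> In (map_node (upd rho k k') n) B)
    by (intros k' n Hn; apply (simulated_old_nodes rho k k' b); auto).
  destruct (HL (rho i) (map_node_labels rho B P (Box psi, i) HPB Hx)) as [m [Hm|Hm]].
  - apply (Hg (upd rho k m)). split; auto.
    intros n Hn. rewrite in_bnodes_app in Hn. simpl in Hn. destruct Hn as [Hn|[<-|[]]]; auto.
    simpl. rewrite upd_eq, upd_neq; auto.
  - destruct (fresh_exists B) as [jB HjB].
    apply (lk_ex B m (rho i) jB Hm HjB).
    apply (Hg (upd rho k jB)). split.
    + intros n Hn. rewrite in_app_iff. rewrite in_bnodes_app in Hn. simpl in Hn.
      destruct Hn as [Hn|[<-|[]]]; [left; auto|].
      right. simpl. rewrite upd_eq, upd_neq; auto.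
    + apply (labels_related_new_edge _ _ (rho i) jB HL); [simpl; auto|].
      intros l Hl. simpl in Hl. destruct Hl as [<-|[<-|[]]]; auto.
Qed.

Lemma rtc_backward {X : Type} (st : X -> X -> Prop) (G : X -> Prop) :
  (forall b b', st b b' -> G b' -> G b) ->
  forall b b', clos_refl_trans_1n _ st b b' -> G b' -> G b.
Proof. intros H b b' Hc. induction Hc; eauto. Qed.

Lemma Forall2_in_l {A B : Type} (Rl : A -> B -> Prop) l1 l2 x :
  Forall2 Rl l1 l2 -> In x l1 -> exists y, In y l2 /\ Rl x y.
Proof.
  induction 1; [intros []|]. intros [->|Hx]; [exists y; simpl; auto|].
  destruct (IHForall2 Hx) as [z [Hz Hr]]. exists z; simpl; auto.
Qed.

Definition all_lk_closable (S : state) : Prop := forall b, In b S -> lk_closable b.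

Lemma all_lk_closable_step456 i S3 S6 :
  step456 i S3 S6 -> all_lk_closable S6 -> all_lk_closable S3.
Proof.
  intros H HG b Hb.
  destruct (Forall2_in_l _ _ _ b H Hb) as [b6 [Hb6 [b4 [b5 [H4 [[H5 _] [H6 _]]]]]]].
  apply (lk_closable_step4 i b b4 H4).
  apply (rtc_backward _ _ (lk_closable_step5_one i) b4 b5 H5).
  apply (rtc_backward _ _ (lk_closable_step6_one i) b5 b6 H6).
  auto.
Qed.

Lemma all_lk_closable_gstep3 S S' : gstep3 S S' -> all_lk_closable S' -> all_lk_closable S.
Proof.
  intros [S1 b S2 bs Hp] HG b' Hb'. apply in_app_iff in Hb'. destruct Hb' as [H|[<-|H]].
  - apply HG. apply in_app_iff; auto.
  - apply (lk_closable_pstep b bs Hp). intros b'' Hb''. apply HG. rewrite !in_app_iff; auto.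
  - apply HG. rewrite !in_app_iff; auto.
Qed.

Lemma complete_run_closed_lk_closable S F :
  complete_run S F -> closed' F -> all_lk_closable S.
Proof.
  induction 1 as [S Hs|S S3 S6 F Hn H3 Hex Hor Hr IH]; intros Hcl.
  - intros b Hb rho B Hsim. apply lk_unsat. intros Hsat.
    unfold closed' in Hcl. rewrite Forall_forall in Hcl.
    exact (Hcl b Hb (simulated_unsat rho b B Hsim Hsat)).
  - apply (rtc_backward _ _ all_lk_closable_gstep3 S S3 H3).
    destruct Hor as [[i [_ H456]]|[_ ->]]; auto. eapply all_lk_closable_step456; eauto.
Qed.

Theorem LK'_closed_LK_derivable (phi : form) :
  pure phi -> closed_complete_LK'_tableau phi -> LKA_derivable phi.
Proof.
  intros Hp [F [Hr Hc]].
  apply (complete_run_closed_lk_closable _ _ Hr Hc _ (or_introl eq_refl) (fun l => l)). split.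
  - intros n [<-|[<-|[]]]; simpl; [left|right; left; reflexivity].
    unfold map_ineq, map_lf; simpl. rewrite unbracket_pure; auto.
  - apply (labels_related_new_edge [] _ 1 2); [intros l []|simpl; auto|].
    intros l Hl. simpl in Hl. destruct Hl as [<-|[<-|[<-|[]]]]; auto.
Qed.

(** * Invariants of the complete LK'(A) procedure *)

Fixpoint modal_depth (f : form) : nat :=
  match f with
  | Var _ | BVar _ | Zero => 0
  | Conj a b | Disj a b | Amp a b | Imp a b => Nat.max (modal_depth a) (modal_depth b)
  | Box a => S (modal_depth a)
  end.

Fixpoint subformulas (f : form) : list form :=
  f :: match f with
       | Conj a b | Disj a b | Amp a b | Imp a b => subformulas a ++ subformulas b
       | Box a => subformulas a
       | _ => []
       end.

Lemma subformulas_refl f : In f (subformulas f).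
Proof. destruct f; simpl; auto. Qed.

Lemma subformulas_trans a b c :
  In a (subformulas b) -> In b (subformulas c) -> In a (subformulas c).
Proof.
  intros Hab Hbc. induction c; simpl in Hbc; destruct Hbc as [<-|Hbc]; auto;
    try contradiction; simpl; right;
    try (apply in_app_iff in Hbc; apply in_app_iff;
         destruct Hbc; [left; apply IHc1|right; apply IHc2]; auto);
    try (apply IHc; auto).
Qed.

Lemma immediate_sub_subformulas a f : immediate_sub a f -> In a (subformulas f).
Proof.
  destruct f; simpl; try tauto;
    intros [->| ->]; right; apply in_app_iff; auto using subformulas_refl.
Qed.

Lemma immediate_sub_modal_depth a f : immediate_sub a f -> (modal_depth a <= modal_depth f)%nat.
Proof. destruct f; simpl; try tauto; intros [->| ->]; lia. Qed.

Lemma immediate_sub_pure a f : immediate_sub a f -> pure f -> pure a.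
Proof. destruct f; simpl; try tauto; intros [->| ->]; tauto. Qed.

(* The formulas that can occur on a branch of the procedure started with [phi]. *)
Definition admissible (phi f : form) : Prop :=
  (pure f /\ In f (subformulas phi)) \/
  (exists a, f = BVar a /\ pure a /\ In (Box a) (subformulas phi)).

Lemma admissible_immediate_sub phi a f : immediate_sub a f -> admissible phi f -> admissible phi a.
Proof.
  intros Hs [[Hp Hi]|[c [-> _]]]; [|destruct Hs].
  left. split; [eapply immediate_sub_pure; eauto|].
  eapply subformulas_trans; [apply immediate_sub_subformulas; eauto|auto].
Qed.

Lemma admissible_Box phi psi :
  admissible phi (Box psi) -> admissible phi (BVar psi) /\ admissible phi psi.
Proof.
  intros [[Hp Hs]|[a [Ha _]]]; [|discriminate]. split.
  - right. exists psi. auto.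
  - left. split; auto. eapply subformulas_trans; [|exact Hs]. simpl. right. apply subformulas_refl.
Qed.

Lemma admissible_pure phi f : admissible phi f -> (forall a, f <> BVar a) -> pure f.
Proof. intros [[H _]|[a [-> _]]] Hn; auto. exfalso; apply (Hn a); auto. Qed.

Definition rel_on (b : branch) (x y : nat) : Prop := In (NR x y) (bnodes b).

Definition modal_at (b : branch) (x : nat) : Prop :=
  exists P y, In (NI P, true) b /\ In y (lhs P ++ rhs P) /\ snd y = x /\
              (1 <= modal_depth (fst y))%nat.

Definition branch_labels (b : branch) : list nat := flat_map node_labels (bnodes b).

Record wf_branch (phi : form) (b : branch) : Prop := {
  wf_admissible : forall P m, In (NI P, m) b ->
    forall y, In y (lhs P ++ rhs P) -> admissible phi (fst y);
  wf_unique_pred : forall x x' y, rel_on b x y -> rel_on b x' y -> x = x';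
  wf_succ_new : forall x y, rel_on b x y -> y <> 1%nat /\ y <> x;
  wf_root : rel_on b 1 2;
  wf_nodup_succs : forall x, NoDup (succs x b)
}.

(* Between rounds, a label with modal formulas in active inequations has only leaves without
   modal formulas as successors, and only the root [1] (with its initial successor [2]) can
   have successors at all while still carrying modal formulas. *)
Record round_inv (phi : form) (b : branch) : Prop := {
  ri_wf : wf_branch phi b;
  ri_modal_leaf : forall x y, rel_on b x y -> modal_at b x ->
    ~ modal_at b y /\ forall z, ~ rel_on b y z;
  ri_modal_root : forall x y, rel_on b x y -> (x, y) <> (1%nat, 2%nat) -> ~ modal_at b x
}.

Definition exhausted_branch (b : branch) : Prop :=
  forall P x, In (NI P, true) b -> In x (lhs P ++ rhs P) -> is_box_or_atom (fst x).

Definition atomic_at (i : nat) (b : branch) : Prop :=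
  forall P y, In (NI P, true) b -> In y (lhs P ++ rhs P) -> snd y = i -> is_box_or_atom (fst y).

Definition no_box_right (i : nat) (b : branch) : Prop := forall psi, existsb (hasR psi i) b = false.
Definition no_box_left (i : nat) (b : branch) : Prop := forall psi, existsb (hasL psi i) b = false.

Definition no_self_succ (i : nat) (b : branch) : Prop := forall j, In j (succs i b) -> j <> i.

Lemma succs_app i b1 b2 : succs i (b1 ++ b2) = succs i b1 ++ succs i b2.
Proof. apply flat_map_app. Qed.

Lemma succs_only_ineqs x (l : branch) : (forall n m, In (n, m) l -> exists Q, n = NI Q) ->
  succs x l = [].
Proof.
  induction l as [|[n m] l IH]; simpl; intros H; auto.
  destruct (H n m (or_introl eq_refl)) as [Q ->]. simpl. apply IH. intros; eapply H; eauto.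
Qed.

Lemma succs_act i cs : succs i (map act cs) = [].
Proof. apply succs_only_ineqs. intros n m H. apply in_map_iff in H. destruct H as [c [E _]].
injection E; eauto. Qed.

Lemma rel_on_succs b x y : rel_on b x y <-> In y (succs x b).
Proof. unfold rel_on. rewrite in_succs, in_bnodes. reflexivity. Qed.

Lemma rel_on_app b1 b2 x y : rel_on (b1 ++ b2) x y <-> rel_on b1 x y \/ rel_on b2 x y.
Proof. apply in_bnodes_app. Qed.

Lemma rel_on_succs_ext b b' : (forall x, succs x b' = succs x b) ->
  forall x y, rel_on b' x y <-> rel_on b x y.
Proof. intros H x y. rewrite !rel_on_succs, H. reflexivity. Qed.

Lemma branch_labels_In b n m x : In (n, m) b -> In x (node_labels n) -> In x (branch_labels b).
Proof. intros H Hx. apply in_flat_map. exists n. split; auto. apply in_bnodes; eauto. Qed.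

Lemma branch_labels_lf b P m y :
  In (NI P, m) b -> In y (lhs P ++ rhs P) -> In (snd y) (branch_labels b).
Proof. intros H Hy. eapply branch_labels_In; eauto. simpl. apply in_map; auto. Qed.

Lemma branch_labels_incl b b' : (forall n, In n (bnodes b) -> In n (bnodes b')) ->
  incl (branch_labels b) (branch_labels b').
Proof.
  intros H x Hx. apply in_flat_map in Hx. destruct Hx as [n [Hn Hx]]. apply in_flat_map. eauto.
Qed.

Lemma rel_on_labels b x y : rel_on b x y -> In x (branch_labels b) /\ In y (branch_labels b).
Proof.
  intros H. apply in_bnodes in H. destruct H as [m Hm].
  split; eapply branch_labels_In; eauto; simpl; auto.
Qed.

Lemma wf_branch_no_self_succ phi b i : wf_branch phi b -> no_self_succ i b.
Proof. intros Hwf j Hj ->. apply rel_on_succs in Hj.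
exact (proj2 (wf_succ_new _ _ Hwf i i Hj) eq_refl). Qed.

Definition branch_choice (a : alt) (cs : list ineq) : Prop :=
  match a with One cs' => cs = cs' | Two c1 c2 => cs = [c1] \/ cs = [c2] end.

Lemma branch_choice_incl a cs : branch_choice a cs -> incl cs (alt_concls a).
Proof.
  destruct a; simpl; [intros ->; apply incl_refl|].
  intros [-> | ->] x [<-|[]]; simpl; auto.
Qed.

Lemma pstep_inv b bs b' : pstep b bs -> In b' bs ->
  exists b1 b2 P a cs, b = b1 ++ (NI P, true) :: b2 /\
    b' = b1 ++ (NI P, false) :: b2 ++ map act cs /\ prop_app P a /\ branch_choice a cs.
Proof.
  intros Hp Hb'. destruct Hp as [b1 b2 P cs Ha|b1 b2 P c1 c2 Ha]; simpl in Hb'.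
  - destruct Hb' as [<-|[]]. exists b1, b2, P, (One cs), cs. simpl; auto.
  - destruct Hb' as [<-|[<-|[]]]; exists b1, b2, P, (Two c1 c2);
      [exists [c1]|exists [c2]]; simpl; auto.
Qed.

Lemma pstep_succs b bs b' : pstep b bs -> In b' bs -> forall x, succs x b' = succs x b.
Proof.
  intros Hp Hb' x. destruct (pstep_inv b bs b' Hp Hb') as [b1 [b2 [P [a [cs [-> [-> _]]]]]]].
  rewrite !succs_app. simpl. rewrite succs_app, succs_act, app_nil_r. reflexivity.
Qed.

Lemma pstep_ineqs b bs b' : pstep b bs -> In b' bs -> forall Q m, In (NI Q, m) b' ->
  (exists m0, In (NI Q, m0) b) \/
  (exists P a, In (NI P, true) b /\ prop_app P a /\ In Q (alt_concls a) /\ m = true).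
Proof.
  intros Hp Hb' Q m H.
  destruct (pstep_inv b bs b' Hp Hb') as [b1 [b2 [P [a [cs [-> [-> [Ha Hc]]]]]]]].
  rewrite in_app_iff in H. simpl in H. rewrite in_app_iff in H.
  destruct H as [H|[H|[H|H]]].
  - left. exists m. apply in_app_iff; auto.
  - injection H as <- _. left. exists true. apply in_app_iff; simpl; auto.
  - left. exists m. apply in_app_iff; simpl; auto.
  - apply in_map_iff in H. destruct H as [c [E Hcs]]. injection E as <- <-.
    right. exists P, a. repeat split; auto; [apply in_app_iff; simpl; auto|].
    apply (branch_choice_incl a cs Hc); auto.
Qed.

Lemma pstep_modal_at b bs b' x : pstep b bs -> In b' bs -> modal_at b' x -> modal_at b x.
Proof.
  intros Hp Hb' [Q [y [HQ [Hy [Hyx Hmd]]]]].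
  destruct (pstep_inv b bs b' Hp Hb') as [b1 [b2 [P [a [cs [-> [-> [Ha Hc]]]]]]]].
  rewrite in_app_iff in HQ. simpl in HQ. rewrite in_app_iff in HQ.
  destruct HQ as [HQ|[HQ|[HQ|HQ]]].
  - exists Q, y. rewrite in_app_iff. auto.
  - discriminate.
  - exists Q, y. rewrite in_app_iff. simpl. auto.
  - apply in_map_iff in HQ. destruct HQ as [c [E Hcs]]. injection E as ->.
    destruct (prop_app_lfs P a Ha Q (branch_choice_incl a cs Hc Q Hcs) y Hy)
      as [z [Hz [Hzy Hor]]].
    exists P, z. repeat split; auto; [apply in_app_iff; simpl; auto|congruence|].
    destruct Hor as [->|Hs]; auto. pose proof (immediate_sub_modal_depth _ _ Hs). lia.
Qed.

Lemma wf_branch_same_succs phi b b' : wf_branch phi b -> (forall x, succs x b' = succs x b) ->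
  (forall P m, In (NI P, m) b' -> forall y, In y (lhs P ++ rhs P) -> admissible phi (fst y)) ->
  wf_branch phi b'.
Proof.
  intros Wb Hs Hadm. pose proof (rel_on_succs_ext _ _ Hs) as HR. constructor; auto.
  - intros x x' y H1 H2. rewrite HR in H1, H2. eapply (wf_unique_pred _ _ Wb); eauto.
  - intros x y H. rewrite HR in H. eapply (wf_succ_new _ _ Wb); eauto.
  - rewrite HR. apply (wf_root _ _ Wb).
  - intros x. rewrite Hs. apply (wf_nodup_succs _ _ Wb).
Qed.

Lemma wf_branch_new_succ phi b b' i j : wf_branch phi b ->
  In i (branch_labels b) -> ~ In j (branch_labels b) ->
  (forall x, succs x b' = succs x b ++ (if PeanoNat.Nat.eqb x i then [j] else [])) ->
  (forall P m, In (NI P, m) b' -> forall y, In y (lhs P ++ rhs P) -> admissible phi (fst y)) ->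
  wf_branch phi b'.
Proof.
  intros Wb Hi Hj Hs Hadm.
  assert (HR : forall x y, rel_on b' x y -> rel_on b x y \/ (x = i /\ y = j)).
  { intros x y H. rewrite rel_on_succs, Hs in H. apply in_app_iff in H.
    destruct H as [H|H]; [left; apply rel_on_succs; auto|].
    destruct (PeanoNat.Nat.eqb_spec x i) as [->|]; [|destruct H].
    destruct H as [<-|[]]. right; auto. }
  constructor; auto.
  - intros x x' y H1 H2.
    destruct (HR x y H1) as [H1'|[E1 E2]]; destruct (HR x' y H2) as [H2'|[E3 E4]].
    + eapply (wf_unique_pred _ _ Wb); eauto.
    + exfalso. apply Hj. rewrite <- E4. apply (rel_on_labels b x y H1').
    + exfalso. apply Hj. rewrite <- E2. apply (rel_on_labels b x' y H2').
    + congruence.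
  - intros x y H. destruct (HR x y H) as [H'|[-> ->]]; [eapply (wf_succ_new _ _ Wb); eauto|].
    split; intros ->; apply Hj; auto. apply (rel_on_labels b 1 2 (wf_root _ _ Wb)).
  - apply rel_on_succs. rewrite Hs. apply in_app_iff. left. apply rel_on_succs, (wf_root _ _ Wb).
  - intros x. rewrite Hs. pose proof (wf_nodup_succs _ _ Wb x).
    destruct (PeanoNat.Nat.eqb_spec x i) as [->|]; [|rewrite app_nil_r; auto].
    apply NoDup_app; auto; [repeat constructor; auto|].
    intros y Hy [<-|[]]. apply Hj. apply (rel_on_labels b i j). apply rel_on_succs; auto.
Qed.

Lemma pstep_wf_branch phi b bs b' : pstep b bs -> In b' bs -> wf_branch phi b -> wf_branch phi b'.
Proof.
  intros Hp Hb' Wb. apply (wf_branch_same_succs phi b); auto; [eapply pstep_succs; eauto|].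
  intros Q m HQ y Hy.
  destruct (pstep_ineqs b bs b' Hp Hb' Q m HQ) as [[m0 H]|[P [a [HP [Ha [Hc _]]]]]];
    [eapply (wf_admissible _ _ Wb); eauto|].
  destruct (prop_app_lfs P a Ha Q Hc y Hy) as [z [Hz [_ [->|Hs]]]];
    [eapply (wf_admissible _ _ Wb); eauto|].
  eapply admissible_immediate_sub; eauto. eapply (wf_admissible _ _ Wb); eauto.
Qed.

Lemma pstep_round_inv phi b bs b' : pstep b bs -> In b' bs -> round_inv phi b -> round_inv phi b'.
Proof.
  intros Hp Hb' Kb. pose proof (rel_on_succs_ext _ _ (pstep_succs b bs b' Hp Hb')) as HR.
  assert (Hm : forall x, modal_at b' x -> modal_at b x) by (intros; eapply pstep_modal_at; eauto).
  constructor.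
  - eapply pstep_wf_branch; eauto. apply (ri_wf _ _ Kb).
  - intros x y Hxy Hx. rewrite HR in Hxy.
    destruct (ri_modal_leaf _ _ Kb x y Hxy (Hm x Hx)) as [H1 H2].
    split; [intros Hy; apply H1; auto|intros z Hz; rewrite HR in Hz; eapply H2; eauto].
  - intros x y Hxy Hne Hx. rewrite HR in Hxy. eapply (ri_modal_root _ _ Kb); eauto.
Qed.

Lemma in_deact h b n m : In (n, m) (deact h b) ->
  exists m0, In (n, m0) b /\ (m = true -> m0 = true /\ h (n, m0) = false).
Proof.
  unfold deact. rewrite in_map_iff. intros [[n0 m0] [Heq Hin]]. simpl in Heq.
  destruct (h (n0, m0)) eqn:E; injection Heq as <- <-; exists m0; split; auto.
  intros; discriminate.
Qed.

Lemma in_deact_false (h : mnode -> bool) b m : In m b -> h m = false -> In m (deact h b).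
Proof. intros H E. apply in_map_iff. exists m. rewrite E. auto. Qed.

Lemma succs_deact x h b : succs x (deact h b) = succs x b.
Proof.
  induction b as [|[n m] b IH]; simpl; auto. rewrite <- IH.
  destruct (h (n, m)); simpl; reflexivity.
Qed.

Lemma concl5_ineqs psi i b n m : In (n, m) (concl5 psi i b) -> exists Q, n = NI Q.
Proof. intros H. apply in_concl5 in H. destruct H as [P [_ [_ H]]]. injection H as -> _. eauto. Qed.

Lemma concl6_ineqs psi i b n m : In (n, m) (concl6 psi i b) -> exists Q, n = NI Q.
Proof. intros H. apply in_concl6 in H. destruct H as [P [_ [_ H]]]. injection H as -> _. eauto. Qed.

Lemma in_repl psi i l y : In y (repl psi i l) ->
  (In y l /\ y <> (Box psi, i)) \/ (y = (BVar psi, i) /\ In (Box psi, i) l).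
Proof.
  unfold repl. rewrite in_map_iff. intros [x [Hx Hin]].
  destruct (lf_eqb x (Box psi, i)) eqn:E.
  - apply lf_eqb_true in E. subst. right; auto.
  - subst. left. split; auto. intros ->. rewrite (proj2 (lf_eqb_true _ _) eq_refl) in E.
    discriminate.
Qed.

Lemma step5_one_inv i b b' : step5_one i b b' -> exists psi j,
  bfresh j b /\ existsb (hasR psi i) b = true /\
  (forall x, succs x b' = succs x b ++ (if PeanoNat.Nat.eqb x i then [j] else [])) /\
  (forall n, In n (bnodes b) -> In n (bnodes b')) /\
  (forall Q m, In (NI Q, m) b' ->
     (exists m0, In (NI Q, m0) b /\ (m = true -> m0 = true /\ hasR psi i (NI Q, m0) = false)) \/
     (exists P, In (NI P, true) b /\ In (Box psi, i) (rhs P) /\ m = true /\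
                Q = mkI (lhs P) (strict P) (repl psi i (rhs P))) \/
     (m = true /\ Q = mkI [(BVar psi, i)] false [(psi, j)])).
Proof.
  intros [psi [j [Hex [Hf ->]]]]. exists psi, j. repeat split; auto.
  - intros x. rewrite !succs_app, succs_deact, (succs_only_ineqs x (concl5 psi i b))
      by apply concl5_ineqs.
    simpl. destruct (PeanoNat.Nat.eqb x i); reflexivity.
  - intros n Hn. rewrite bnodes_app, bnodes_deact. apply in_app_iff; auto.
  - intros Q m H. apply in_app_iff in H. destruct H as [H|H]; [left; apply in_deact in H; exact H|].
    apply in_app_iff in H. destruct H as [H|[H|[H|[]]]].
    + apply in_concl5 in H. destruct H as [P [HP [Hb Heq]]]. injection Heq as HQ Hm. subst.
      right; left. exists P. auto.
    + injection H as HQ Hm. subst. right; right; auto.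
    + discriminate.
Qed.

Lemma step6_one_inv i b b' : step6_one i b b' -> exists psi,
  existsb (hasL psi i) b = true /\
  (forall x, succs x b' = succs x b) /\
  (forall n, In n (bnodes b) -> In n (bnodes b')) /\
  (forall Q m, In (NI Q, m) b' ->
     (exists m0, In (NI Q, m0) b /\ (m = true -> m0 = true /\ hasL psi i (NI Q, m0) = false)) \/
     (exists P, In (NI P, true) b /\ In (Box psi, i) (lhs P) /\ m = true /\
                Q = mkI (repl psi i (lhs P)) (strict P) (rhs P)) \/
     (exists j, In j (succs i b) /\ m = true /\ Q = mkI [(psi, j)] false [(BVar psi, i)])).
Proof.
  intros [psi [Hex ->]]. exists psi. repeat split; auto.
  - intros x. rewrite !succs_app, succs_deact, (succs_only_ineqs x (concl6 psi i b))
      by apply concl6_ineqs.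
    rewrite (succs_only_ineqs x (map _ (succs i b))), !app_nil_r; auto.
    intros n m H. apply in_map_iff in H. destruct H as [j [H _]]. injection H as <- _. eauto.
  - intros n Hn. rewrite bnodes_app, bnodes_deact. apply in_app_iff; auto.
  - intros Q m H. apply in_app_iff in H. destruct H as [H|H]; [left; apply in_deact in H; exact H|].
    apply in_app_iff in H. destruct H as [H|H].
    + apply in_concl6 in H. destruct H as [P [HP [Hb Heq]]]. injection Heq as HQ Hm. subst.
      right; left. exists P. auto.
    + apply in_map_iff in H. destruct H as [j [Heq Hj]]. injection Heq as HQ Hm. subst.
      right; right. eauto.
Qed.

Lemma rel_on_step5_one i b b' x y : step5_one i b b' -> rel_on b' x y ->
  rel_on b x y \/ (x = i /\ ~ In y (branch_labels b)).
Proof.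
  intros Hs H. destruct (step5_one_inv i b b' Hs) as [psi [j [Hf [_ [Hsu _]]]]].
  rewrite rel_on_succs, Hsu in H. apply in_app_iff in H.
  destruct H as [H|H]; [left; apply rel_on_succs; auto|].
  destruct (PeanoNat.Nat.eqb_spec x i) as [->|]; [|destruct H].
  destruct H as [<-|[]]. right; auto.
Qed.

Lemma step5_one_succs_incl i b b' x : step5_one i b b' -> incl (succs x b) (succs x b').
Proof.
  intros Hs z Hz. destruct (step5_one_inv i b b' Hs) as [psi [j [_ [_ [Hsu _]]]]].
  rewrite Hsu. apply in_app_iff; auto.
Qed.

Lemma step5_one_labels_incl i b b' : step5_one i b b' -> incl (branch_labels b) (branch_labels b').
Proof.
  intros Hs. destruct (step5_one_inv i b b' Hs) as [psi [j [_ [_ [_ [Hbn _]]]]]].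
  apply branch_labels_incl; auto.
Qed.

Lemma rel_on_step5_one_old i b b' x y : step5_one i b b' -> rel_on b x y -> rel_on b' x y.
Proof.
  intros Hs. destruct (step5_one_inv i b b' Hs) as [psi [j [_ [_ [_ [Hbn _]]]]]]. apply Hbn.
Qed.

Lemma rel_on_step6_one i b b' x y : step6_one i b b' -> rel_on b' x y <-> rel_on b x y.
Proof.
  intros Hs. destruct (step6_one_inv i b b' Hs) as [psi [_ [Hsu _]]].
  apply rel_on_succs_ext; auto.
Qed.

Lemma succs_step6_one i b b' x : step6_one i b b' -> succs x b' = succs x b.
Proof. intros Hs. destruct (step6_one_inv i b b' Hs) as [psi [_ [Hsu _]]]. auto. Qed.

Lemma step5_one_modal_at i b b' x : step5_one i b b' -> modal_at b' x ->
  modal_at b x \/ In x (succs i b').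
Proof.
  intros Hs [Q [y [HQ [Hy [Hyx Hmd]]]]].
  destruct (step5_one_inv i b b' Hs) as [psi [j [Hf [Hex [Hsu [Hbn Hsh]]]]]].
  destruct (Hsh Q true HQ) as [[m0 [H0 H1]]|[[P [HP [_ [_ ->]]]]|[_ ->]]].
  - destruct (H1 eq_refl) as [-> _]. left. exists Q, y. auto.
  - simpl in Hy. rewrite in_app_iff in Hy. destruct Hy as [Hy|Hy].
    + left. exists P, y. rewrite in_app_iff. auto.
    + apply in_repl in Hy. destruct Hy as [[Hy _]|[-> _]]; [|simpl in Hmd; lia].
      left. exists P, y. rewrite in_app_iff. auto.
  - simpl in Hy. destruct Hy as [<-|[<-|[]]]; [simpl in Hmd; lia|].
    right. simpl in Hyx. subst x. rewrite Hsu, PeanoNat.Nat.eqb_refl. apply in_app_iff. simpl; auto.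
Qed.

Lemma step6_one_modal_at i b b' x : step6_one i b b' -> modal_at b' x ->
  modal_at b x \/ In x (succs i b').
Proof.
  intros Hs [Q [y [HQ [Hy [Hyx Hmd]]]]].
  destruct (step6_one_inv i b b' Hs) as [psi [Hex [Hsu [Hbn Hsh]]]].
  destruct (Hsh Q true HQ) as [[m0 [H0 H1]]|[[P [HP [_ [_ ->]]]]|[j [Hj [_ ->]]]]].
  - destruct (H1 eq_refl) as [-> _]. left. exists Q, y. auto.
  - simpl in Hy. rewrite in_app_iff in Hy. destruct Hy as [Hy|Hy].
    + apply in_repl in Hy. destruct Hy as [[Hy _]|[-> _]]; [|simpl in Hmd; lia].
      left. exists P, y. rewrite in_app_iff. auto.
    + left. exists P, y. rewrite in_app_iff. auto.
  - simpl in Hy. destruct Hy as [<-|[<-|[]]]; [|simpl in Hmd; lia].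
    right. simpl in Hyx. subst x. rewrite Hsu. auto.
Qed.

Lemma step5_one_wf_branch phi i b b' : step5_one i b b' -> wf_branch phi b -> wf_branch phi b'.
Proof.
  intros Hs Wb. destruct (step5_one_inv i b b' Hs) as [psi [j [Hf [Hex [Hsu [_ Hsh]]]]]].
  destruct (proj1 (existsb_hasR psi i b) Hex) as [P0 [HP0 HB0]].
  pose proof (admissible_Box phi psi (wf_admissible _ _ Wb P0 true HP0 (Box psi, i)
    ltac:(apply in_app_iff; auto))) as [W1 W2].
  apply (wf_branch_new_succ phi b b' i j); auto.
  - apply (branch_labels_lf b P0 true (Box psi, i)); auto. apply in_app_iff; auto.
  - intros Q m HQ y Hy.
    destruct (Hsh Q m HQ) as [[m0 [H0 _]]|[[P [HP [Hb [_ ->]]]]|[_ ->]]].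
    + eapply (wf_admissible _ _ Wb); eauto.
    + simpl in Hy. rewrite in_app_iff in Hy. destruct Hy as [Hy|Hy].
      * eapply (wf_admissible _ _ Wb); eauto. apply in_app_iff; auto.
      * apply in_repl in Hy. destruct Hy as [[Hy _]|[-> _]]; auto.
        eapply (wf_admissible _ _ Wb); eauto. apply in_app_iff; auto.
    + simpl in Hy. destruct Hy as [<-|[<-|[]]]; auto.
Qed.

Lemma step6_one_wf_branch phi i b b' : step6_one i b b' -> wf_branch phi b -> wf_branch phi b'.
Proof.
  intros Hs Wb. destruct (step6_one_inv i b b' Hs) as [psi [Hex [Hsu [_ Hsh]]]].
  destruct (proj1 (existsb_hasL psi i b) Hex) as [P0 [HP0 HB0]].
  pose proof (admissible_Box phi psi (wf_admissible _ _ Wb P0 true HP0 (Box psi, i)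
    ltac:(apply in_app_iff; auto))) as [W1 W2].
  apply (wf_branch_same_succs phi b); auto.
  intros Q m HQ y Hy.
  destruct (Hsh Q m HQ) as [[m0 [H0 _]]|[[P [HP [Hb [_ ->]]]]|[j [Hj [_ ->]]]]].
  - eapply (wf_admissible _ _ Wb); eauto.
  - simpl in Hy. rewrite in_app_iff in Hy. destruct Hy as [Hy|Hy].
    + apply in_repl in Hy. destruct Hy as [[Hy _]|[-> _]]; auto.
      eapply (wf_admissible _ _ Wb); eauto. apply in_app_iff; auto.
    + eapply (wf_admissible _ _ Wb); eauto. apply in_app_iff; auto.
  - simpl in Hy. destruct Hy as [<-|[<-|[]]]; auto.
Qed.

Lemma step5_one_atomic_at i b b' : step5_one i b b' -> atomic_at i b -> atomic_at i b'.
Proof.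
  intros Hs HA Q y HQ Hy Hyi.
  destruct (step5_one_inv i b b' Hs) as [psi [j [Hf [Hex [_ [_ Hsh]]]]]].
  destruct (Hsh Q true HQ) as [[m0 [H0 H1]]|[[P [HP [_ [_ ->]]]]|[_ ->]]].
  - destruct (H1 eq_refl) as [-> _]. eapply HA; eauto.
  - simpl in Hy. rewrite in_app_iff in Hy. destruct Hy as [Hy|Hy].
    + eapply HA; eauto. apply in_app_iff; auto.
    + apply in_repl in Hy. destruct Hy as [[Hy _]|[-> _]]; [|simpl; auto].
      eapply HA; eauto. apply in_app_iff; auto.
  - simpl in Hy. destruct Hy as [<-|[<-|[]]]; simpl; auto. simpl in Hyi. subst j.
    destruct (proj1 (existsb_hasR psi i b) Hex) as [P0 [HP0 HB0]].
    exfalso. apply (bfresh_lf i b P0 true (Box psi, i) Hf HP0); auto. apply in_app_iff; auto.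
Qed.

Lemma step5_one_no_self_succ i b b' : step5_one i b b' -> no_self_succ i b -> no_self_succ i b'.
Proof.
  intros Hs Hsi j' Hj'. destruct (step5_one_inv i b b' Hs) as [psi [j [Hf [Hex [Hsu _]]]]].
  rewrite Hsu, PeanoNat.Nat.eqb_refl in Hj'. apply in_app_iff in Hj'.
  destruct Hj' as [H|[<-|[]]]; auto. intros Eji.
  destruct (proj1 (existsb_hasR psi i b) Hex) as [P0 [HP0 HB0]].
  apply (bfresh_lf j b P0 true (Box psi, i) Hf HP0); [apply in_app_iff; auto|simpl; congruence].
Qed.

Lemma step6_one_atomic_at i b b' : step6_one i b b' -> no_self_succ i b ->
  atomic_at i b -> atomic_at i b'.
Proof.
  intros Hs Hsi HA Q y HQ Hy Hyi.
  destruct (step6_one_inv i b b' Hs) as [psi [Hex [_ [_ Hsh]]]].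
  destruct (Hsh Q true HQ) as [[m0 [H0 H1]]|[[P [HP [_ [_ ->]]]]|[j [Hj [_ ->]]]]].
  - destruct (H1 eq_refl) as [-> _]. eapply HA; eauto.
  - simpl in Hy. rewrite in_app_iff in Hy. destruct Hy as [Hy|Hy].
    + apply in_repl in Hy. destruct Hy as [[Hy _]|[-> _]]; [|simpl; auto].
      eapply HA; eauto. apply in_app_iff; auto.
    + eapply HA; eauto. apply in_app_iff; auto.
  - simpl in Hy. destruct Hy as [<-|[<-|[]]]; simpl; auto. simpl in Hyi.
    exfalso; apply (Hsi j); auto.
Qed.

Lemma step6_one_no_box_right i b b' : step6_one i b b' -> no_box_right i b -> no_box_right i b'.
Proof.
  intros Hs HnR psi'. apply Bool.not_true_iff_false. rewrite existsb_hasR.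
  intros [Q [HQ HBQ]]. destruct (step6_one_inv i b b' Hs) as [psi [_ [_ [_ Hsh]]]].
  specialize (HnR psi'). rewrite <- Bool.not_true_iff_false, existsb_hasR in HnR. apply HnR.
  destruct (Hsh Q true HQ) as [[m0 [H0 H1]]|[[P [HP [_ [_ ->]]]]|[j [Hj [_ ->]]]]].
  - destruct (H1 eq_refl) as [-> _]. eauto.
  - eauto.
  - simpl in HBQ. destruct HBQ as [H|[]]. discriminate.
Qed.

Lemma succs_add_rel b i k x (m : bool) :
  succs x (b ++ [(NR i k, m)]) = succs x b ++ (if PeanoNat.Nat.eqb x i then [k] else []).
Proof. rewrite succs_app. simpl. destruct (PeanoNat.Nat.eqb x i); reflexivity. Qed.

Lemma ineqs_add_rel b i k P (m m' : bool) : In (NI P, m) (b ++ [(NR i k, m')]) <-> In (NI P, m) b.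
Proof. rewrite in_app_iff. simpl. intuition discriminate. Qed.

Lemma modal_at_add_rel b i k (m : bool) x : modal_at (b ++ [(NR i k, m)]) x <-> modal_at b x.
Proof.
  unfold modal_at. split; intros [P [y [HP Hy]]]; exists P, y; rewrite ?ineqs_add_rel in *; auto.
Qed.

Lemma rel_on_add_rel b i k (m : bool) x y : rel_on (b ++ [(NR i k, m)]) x y <->
  rel_on b x y \/ (x = i /\ y = k).
Proof.
  rewrite !rel_on_succs, succs_add_rel, in_app_iff.
  destruct (PeanoNat.Nat.eqb_spec x i); simpl; intuition congruence.
Qed.

Lemma has_box_at_label i b : has_box_at i b -> In i (branch_labels b).
Proof.
  intros [P [psi [HP Hx]]]. apply (branch_labels_lf b P true (Box psi, i) HP Hx).
Qed.

Lemma has_box_at_modal_at i b : has_box_at i b -> modal_at b i.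
Proof. intros [P [psi [HP Hx]]]. exists P, (Box psi, i). repeat split; auto. simpl. lia. Qed.

Lemma step4_wf_branch phi i b k : bfresh k b -> has_box_at i b -> wf_branch phi b ->
  wf_branch phi (b ++ [(NR i k, false)]).
Proof.
  intros Hf Hb Wb. apply (wf_branch_new_succ phi b _ i k); auto using has_box_at_label.
  - intros x. apply succs_add_rel.
  - intros P m HP. rewrite ineqs_add_rel in HP. eapply (wf_admissible _ _ Wb); eauto.
Qed.

Record round_progress (phi : form) (i : nat) (b3 b : branch) : Prop := {
  rp_labels : incl (branch_labels b3) (branch_labels b);
  rp_rel : forall x y, rel_on b x y -> rel_on b3 x y \/ (x = i /\ ~ In y (branch_labels b3));
  rp_modal : forall x, modal_at b x -> modal_at b3 x \/ In x (succs i b);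
  rp_wf : wf_branch phi b;
  rp_atomic : atomic_at i b;
  rp_no_self : no_self_succ i b;
  rp_succ : exists k, In k (succs i b)
}.

Lemma round_progress_step4 phi i b3 k : round_inv phi b3 -> exhausted_branch b3 ->
  bfresh k b3 -> has_box_at i b3 -> round_progress phi i b3 (b3 ++ [(NR i k, false)]).
Proof.
  intros Kb Hex Hf Hb.
  assert (Hki : k <> i) by (intros ->; exact (Hf (has_box_at_label i b3 Hb))).
  constructor.
  - apply branch_labels_incl. intros n Hn. rewrite bnodes_app. apply in_app_iff; auto.
  - intros x y H. apply rel_on_add_rel in H. destruct H as [H|[-> ->]]; auto.
  - intros x H. left. apply modal_at_add_rel in H. auto.
  - apply step4_wf_branch; auto. apply (ri_wf _ _ Kb).
  - intros P y HP. rewrite ineqs_add_rel in HP. eauto.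
  - intros j Hj. rewrite succs_add_rel, PeanoNat.Nat.eqb_refl in Hj. apply in_app_iff in Hj.
    destruct Hj as [H|[<-|[]]]; auto. apply (wf_branch_no_self_succ phi b3 i (ri_wf _ _ Kb)); auto.
  - exists k. rewrite succs_add_rel, PeanoNat.Nat.eqb_refl. apply in_app_iff; simpl; auto.
Qed.

Lemma round_progress_step5_one phi i b3 b b' :
  round_progress phi i b3 b -> step5_one i b b' -> round_progress phi i b3 b'.
Proof.
  intros [A1 A2 A3 A4 A5 A6 [k A7]] Hs.
  pose proof (step5_one_succs_incl i b b' i Hs) as Hsi. constructor.
  - intros x Hx. apply (step5_one_labels_incl i b b' Hs); auto.
  - intros x y H. destruct (rel_on_step5_one i b b' x y Hs H) as [H'|[-> Hy]]; [apply A2; auto|].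
    right; split; auto; intros Hy'; apply Hy; apply A1; auto.
  - intros x H. destruct (step5_one_modal_at i b b' x Hs H) as [H'|H']; auto.
    destruct (A3 x H'); auto.
  - apply (step5_one_wf_branch phi i b b' Hs A4).
  - apply (step5_one_atomic_at i b b' Hs A5).
  - apply (step5_one_no_self_succ i b b' Hs A6).
  - exists k. auto.
Qed.

Lemma round_progress_step6_one phi i b3 b b' :
  round_progress phi i b3 b -> step6_one i b b' -> round_progress phi i b3 b'.
Proof.
  intros [A1 A2 A3 A4 A5 A6 [k A7]] Hs.
  pose proof (succs_step6_one i b b' i Hs) as Hsi. constructor.
  - intros x Hx. destruct (step6_one_inv i b b' Hs) as [psi [_ [_ [Hbn _]]]].
    apply (branch_labels_incl b b' Hbn); auto.
  - intros x y H. rewrite (rel_on_step6_one i b b' x y Hs) in H. auto.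
  - intros x H. rewrite Hsi. destruct (step6_one_modal_at i b b' x Hs H) as [H'|H'];
      [destruct (A3 x H')|rewrite <- Hsi]; auto.
  - apply (step6_one_wf_branch phi i b b' Hs A4).
  - apply (step6_one_atomic_at i b b' Hs A6 A5).
  - intros j. rewrite Hsi. auto.
  - exists k. rewrite Hsi. auto.
Qed.

Lemma rtc_forward {X : Type} (st : X -> X -> Prop) (Inv : X -> Prop) :
  (forall b b', Inv b -> st b b' -> Inv b') ->
  forall b b', clos_refl_trans_1n _ st b b' -> Inv b -> Inv b'.
Proof. intros H b b' Hc. induction Hc; eauto. Qed.

Lemma rtc_stuck {X : Type} (st : X -> X -> Prop) b b' :
  (forall b'', ~ st b b'') -> clos_refl_trans_1n _ st b b' -> b' = b.
Proof. intros H Hc. destruct Hc; auto. exfalso; eapply H; eauto. Qed.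

Lemma modal_atomic_has_box b x : atomic_at x b -> modal_at b x ->
  ~ no_box_right x b \/ ~ no_box_left x b.
Proof.
  intros HA [P [y [HP [Hy [Hyx Hmd]]]]].
  pose proof (HA P y HP Hy Hyx) as Hb. destruct y as [f l]; simpl in *; subst l.
  destruct f; simpl in Hb, Hmd; try lia; try contradiction.
  apply in_app_iff in Hy. destruct Hy as [Hy|Hy]; [right|left]; intros Hno;
    specialize (Hno f); rewrite <- Bool.not_true_iff_false in Hno; apply Hno;
    [apply existsb_hasL|apply existsb_hasR]; eauto.
Qed.

Lemma round_without_box i b3 b4 b5 b6 : step4 i b3 b4 -> step5 i b4 b5 -> step6 i b5 b6 ->
  ~ has_box_at i b3 -> b6 = b3.
Proof.
  intros H4 [H5 _] [H6 _] Hn.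
  destruct H4 as [[Hb _]|[_ ->]]; [contradiction|].
  assert (N5 : forall b'', ~ step5_one i b3 b'').
  { intros b'' [psi [j [Hex _]]]. apply existsb_hasR in Hex. destruct Hex as [P [HP HB]].
    apply Hn. exists P, psi. split; auto. apply in_app_iff; auto. }
  assert (N6 : forall b'', ~ step6_one i b3 b'').
  { intros b'' [psi [Hex _]]. apply existsb_hasL in Hex. destruct Hex as [P [HP HB]].
    apply Hn. exists P, psi. split; auto. apply in_app_iff; auto. }
  rewrite (rtc_stuck _ _ _ N5 H5) in H6. exact (rtc_stuck _ _ _ N6 H6).
Qed.

Definition round (i : nat) (b b' : branch) : Prop :=
  exists b4 b5, step4 i b b4 /\ step5 i b4 b5 /\ step6 i b5 b'.

Lemma round_progress_of_round phi i b3 b6 : round_inv phi b3 -> exhausted_branch b3 ->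
  has_box_at i b3 -> round i b3 b6 ->
  round_progress phi i b3 b6 /\ no_box_right i b6 /\ no_box_left i b6.
Proof.
  intros Kb Hex Hb [b4 [b5 [H4 [[H5 HnR5] [H6 HnL6]]]]].
  destruct H4 as [[_ [k [Hf ->]]]|[Hn _]]; [|contradiction].
  pose proof (round_progress_step4 phi i b3 k Kb Hex Hf Hb) as A4.
  pose proof (rtc_forward _ _ (round_progress_step5_one phi i b3) _ _ H5 A4) as A5.
  split; [exact (rtc_forward _ _ (round_progress_step6_one phi i b3) _ _ H6 A5)|split; auto].
  exact (rtc_forward _ _ (fun b b' H Hs => step6_one_no_box_right i b b' Hs H) _ _ H6 HnR5).
Qed.

(* After the round, [i] carries no modal formula any more, and its successors are new leaves. *)
Lemma round_progress_round_inv phi i b3 b6 : round_inv phi b3 -> modal_at b3 i ->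
  round_progress phi i b3 b6 -> no_box_right i b6 -> no_box_left i b6 -> round_inv phi b6.
Proof.
  intros Kb Hi3 [D1 D2 D3 D4 D5 D6 D7] HnR HnL.
  assert (Hi6 : ~ modal_at b6 i)
    by (intros Hh; destruct (modal_atomic_has_box b6 i D5 Hh) as [H|H]; auto).
  assert (Hroot : forall x y, rel_on b6 x y -> (x, y) <> (1%nat, 2%nat) -> ~ modal_at b6 x).
  { intros x y Hxy Hne Hx.
    destruct (D2 x y Hxy) as [H3|[-> _]]; [|contradiction].
    destruct (D3 x Hx) as [Hx3|Hxs]; [exact (ri_modal_root _ _ Kb x y H3 Hne Hx3)|].
    apply rel_on_succs in Hxs. destruct (D2 i x Hxs) as [Hix|[_ Hx']].
    - exact (proj2 (ri_modal_leaf _ _ Kb i x Hix Hi3) y H3).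
    - exact (Hx' (proj1 (rel_on_labels b3 x y H3))). }
  constructor; auto. intros x y Hxy Hx.
  destruct (PeanoNat.Nat.eq_dec x 1) as [->|Hx1];
    [destruct (PeanoNat.Nat.eq_dec y 2) as [->|Hy2]|];
    [|exfalso; apply (Hroot 1%nat y Hxy); auto; intros E; injection E; auto
     |exfalso; apply (Hroot x y Hxy); auto; intros E; injection E; auto].
  destruct (D3 1%nat Hx) as [H13|H1s].
  2:{ exfalso. apply rel_on_succs in H1s. exact (proj1 (wf_succ_new _ _ D4 i 1 H1s) eq_refl). }
  destruct (ri_modal_leaf _ _ Kb 1 2 (wf_root _ _ (ri_wf _ _ Kb)) H13) as [N2 N2s]. split.
  - intros H2. destruct (D3 2%nat H2) as [H23|H2s]; [contradiction|].
    apply rel_on_succs in H2s. rewrite (wf_unique_pred _ _ D4 i 1 2 H2s Hxy) in Hi6. contradiction.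
  - intros z Hz. destruct (D2 2%nat z Hz) as [H|[E _]]; [apply (N2s z); auto|].
    subst i. contradiction.
Qed.

Lemma round_preserves_inv phi i b3 b6 : round_inv phi b3 -> exhausted_branch b3 ->
  round i b3 b6 -> round_inv phi b6.
Proof.
  intros Kb Hex Hr. destruct (classic (has_box_at i b3)) as [Hb|Hn].
  - destruct (round_progress_of_round phi i b3 b6 Kb Hex Hb Hr) as [A [HnR HnL]].
    exact (round_progress_round_inv phi i b3 b6 Kb (has_box_at_modal_at i b3 Hb) A HnR HnL).
  - destruct Hr as [b4 [b5 [H4 [H5 H6]]]]. rewrite (round_without_box i b3 b4 b5 b6); auto.
Qed.

(** * Open complete tableaux yield countermodels *)

Lemma rule_slack_choice v P a cs : rule_slack v P a -> branch_choice a cs ->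
  exists c, In c cs /\ strict c = strict P /\ slack v c <= slack v P.
Proof.
  destruct a as [cs'|c1 c2]; simpl.
  - intros [Hall [c [Hc Hle]]] ->. exists c. split; auto. split; auto. apply (Hall c Hc).
  - intros [Hs1 [Hs2 [_ [Hl1 Hl2]]]] [-> | ->]; eexists; split; simpl; eauto.
Qed.

Lemma sumv_repl_le v psi i l : v (Box psi) i <= v (BVar psi) i -> sumv v l <= sumv v (repl psi i l).
Proof.
  intros H. induction l as [|x l IH]; [unfold repl; simpl; lra|].
  change (repl psi i (x :: l))
    with ((if lf_eqb x (Box psi, i) then (BVar psi, i) else x) :: repl psi i l).
  simpl. destruct (lf_eqb x (Box psi, i)) eqn:E; [apply lf_eqb_true in E; subst; simpl|]; lra.
Qed.

Lemma sumv_repl_ge v psi i l : v (BVar psi) i <= v (Box psi) i -> sumv v (repl psi i l) <= sumv v l.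
Proof.
  intros H. induction l as [|x l IH]; [unfold repl; simpl; lra|].
  change (repl psi i (x :: l))
    with ((if lf_eqb x (Box psi, i) then (BVar psi, i) else x) :: repl psi i l).
  simpl. destruct (lf_eqb x (Box psi, i)) eqn:E; [apply lf_eqb_true in E; subst; simpl|]; lra.
Qed.

Lemma holds_single v a x c y : holds v (mkI [(a, x)] false [(c, y)]) -> v c y <= v a x.
Proof. unfold holds, sumv; simpl. lra. Qed.

Lemma in_concl5_intro psi i b P : In (NI P, true) b -> hasR psi i (NI P, true) = true ->
  In (act (mkI (lhs P) (strict P) (repl psi i (rhs P)))) (concl5 psi i b).
Proof. intros H E. apply in_flat_map. exists (NI P, true). rewrite E. simpl; auto. Qed.

Lemma in_concl6_intro psi i b P : In (NI P, true) b -> hasL psi i (NI P, true) = true ->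
  In (act (mkI (repl psi i (lhs P)) (strict P) (rhs P))) (concl6 psi i b).
Proof. intros H E. apply in_flat_map. exists (NI P, true). rewrite E. simpl; auto. Qed.

Definition admissible_branch (phi : form) (b : branch) : Prop :=
  forall P m, In (NI P, m) b -> forall y, In y (lhs P ++ rhs P) -> admissible phi (fst y).

Lemma admissible_branch_box_pure phi b P psi i : admissible_branch phi b ->
  In (NI P, true) b -> In (Box psi, i) (lhs P ++ rhs P) -> pure psi.
Proof.
  intros Hw HP Hx. pose proof (Hw P true HP (Box psi, i) Hx) as W.
  apply admissible_pure in W; [exact W|intros ? E; discriminate].
Qed.

Section Countermodel.

Variables (RelM : nat -> nat -> Prop) (VM : nat -> nat -> R) (vB : form -> nat -> R) (r : R).
Hypothesis r_ge0 : 0 <= r.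
Hypothesis VM_bounded : forall p x, Rabs (VM p x) <= r.

Definition eval_bracket (f : form) (x : nat) : R :=
  match f with BVar a => vB a x | _ => eval RelM VM f x end.

Lemma eval_bracket_pure f x : pure f -> eval_bracket f x = eval RelM VM f x.
Proof. destruct f; simpl; tauto. Qed.

Definition models_branch (Cs : nat -> Prop) (b : branch) : Prop :=
  (forall P, In (NI P, true) b -> holds eval_bracket P) /\
  (forall x y, rel_on b x y -> RelM x y) /\
  (forall x y, Cs x -> RelM x y -> rel_on b x y).

Lemma models_branch_weaken (Cs Cs' : nat -> Prop) b : (forall x, Cs' x -> Cs x) ->
  models_branch Cs b -> models_branch Cs' b.
Proof. intros H [H1 [H2 H3]]. repeat split; auto. Qed.

Lemma eval_bracket_rule_slack phi P a :
  prop_app P a -> (forall y, In y (lhs P ++ rhs P) -> admissible phi (fst y)) ->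
  rule_slack eval_bracket P a.
Proof.
  intros Ha Hw. apply (prop_rule_slack _ (admissible phi)); auto; intros;
    repeat match goal with H : admissible phi ?f |- _ =>
      let Hp := fresh in
      assert (Hp : pure f) by (apply (admissible_pure phi); auto; intros ? E; discriminate E);
      clear H end; simpl in *;
    repeat rewrite eval_bracket_pure by tauto; reflexivity.
Qed.

Lemma models_branch_pstep phi Cs b bs b' : pstep b bs -> In b' bs -> admissible_branch phi b ->
  models_branch Cs b' -> models_branch Cs b.
Proof.
  intros Hp Hb' Hw [H1 [H2 H3]].
  pose proof (rel_on_succs_ext _ _ (pstep_succs b bs b' Hp Hb')) as HR.
  repeat split; [|intros x y H; apply H2, HR; auto|intros x y Hx H; apply HR; auto].
  destruct (pstep_inv b bs b' Hp Hb') as [b1 [b2 [P [a [cs [-> [-> [Ha Hc]]]]]]]].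
  intros Q HQ. apply in_app_iff in HQ. simpl in HQ. destruct HQ as [HQ|[HQ|HQ]].
  - apply H1. apply in_app_iff; auto.
  - injection HQ as ->.
    assert (HP : In (NI Q, true) (b1 ++ (NI Q, true) :: b2)) by (apply in_app_iff; simpl; auto).
    destruct (rule_slack_choice _ _ _ cs (eval_bracket_rule_slack phi Q a Ha (Hw Q true HP)) Hc)
      as [c [Hcs [Hs Hle]]].
    pose proof (H1 c ltac:(apply in_app_iff; right; right; apply in_app_iff; right;
      apply in_map_iff; exists c; auto)) as Hc'.
    rewrite holds_slack in Hc' |- *. rewrite Hs in Hc'. destruct (strict Q); lra.
  - apply H1. apply in_app_iff; right; right; apply in_app_iff; auto.
Qed.

(* The new inequation  [□ψ]^i ≥ ψ^j  at the successor j gives  (□ψ)^i ≤ [□ψ]^i  in the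
   model, so replacing (□ψ)^i by [□ψ]^i on a right-hand side only strengthens an inequation. *)
Lemma models_branch_step5_one phi Cs i b b' : step5_one i b b' -> ~ Cs i ->
  admissible_branch phi b -> models_branch Cs b' -> models_branch Cs b.
Proof.
  intros Hs HCi Hw [H1 [H2 H3]].
  destruct (step5_one_inv i b b' Hs) as [psi0 [j0 [_ [_ [Hsu [Hbn _]]]]]].
  destruct Hs as [psi [j [Hex [Hf Hb']]]].
  destruct (proj1 (existsb_hasR psi i b) Hex) as [P0 [HP0 HB0]].
  assert (Hpsi : pure psi)
    by (apply (admissible_branch_box_pure phi b P0 psi i Hw HP0); apply in_app_iff; auto).
  rewrite Hb' in H1.
  assert (HR : RelM i j).
  { apply H2. rewrite Hb'. unfold rel_on. rewrite !bnodes_app. apply in_app_iff; right.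
    apply in_app_iff; right. simpl; auto. }
  assert (HBle : eval_bracket (Box psi) i <= eval_bracket (BVar psi) i).
  { assert (HM : holds eval_bracket (mkI [(BVar psi, i)] false [(psi, j)]))
      by (apply H1; apply in_app_iff; right; apply in_app_iff; right; simpl; auto).
    apply holds_single in HM. rewrite (eval_bracket_pure psi j Hpsi) in HM.
    pose proof (eval_Box_le nat RelM VM r r_ge0 VM_bounded psi i j HR).
    change (eval_bracket (Box psi) i) with (eval RelM VM (Box psi) i). lra. }
  repeat split.
  - intros P HP. destruct (hasR psi i (NI P, true)) eqn:E.
    + pose proof (H1 _ (proj2 (in_app_iff _ _ _) (or_intror (proj2 (in_app_iff _ _ _)
        (or_introl (in_concl5_intro psi i b P HP E)))))) as HQ.
      unfold holds in HQ |- *; simpl in HQ.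
      pose proof (sumv_repl_le eval_bracket psi i (rhs P) HBle). destruct (strict P); lra.
    + apply H1. apply in_app_iff; left. apply in_deact_false; auto.
  - intros x y H. apply H2. apply Hbn; auto.
  - intros x y Hx Hr. specialize (H3 x y Hx Hr).
    rewrite rel_on_succs, Hsu in H3. apply in_app_iff in H3. destruct H3 as [H3|H3].
    + apply rel_on_succs; auto.
    + destruct (PeanoNat.Nat.eqb_spec x i) as [->|]; [contradiction|destruct H3].
Qed.

(* Dually,  ψ^j ≥ [□ψ]^i  for all successors j on the branch gives  [□ψ]^i ≤ (□ψ)^i,
   provided these are all the successors of i in the model. *)
Lemma models_branch_step6_one phi Cs i b b' : step6_one i b b' -> Cs i ->
  (exists k, rel_on b i k) -> admissible_branch phi b -> models_branch Cs b' -> models_branch Cs b.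
Proof.
  intros Hs HCi [k Hk] Hw [H1 [H2 H3]].
  pose proof (fun x y => rel_on_step6_one i b b' x y Hs) as HR.
  destruct Hs as [psi [Hex Hb']].
  destruct (proj1 (existsb_hasL psi i b) Hex) as [P0 [HP0 HB0]].
  assert (Hpsi : pure psi)
    by (apply (admissible_branch_box_pure phi b P0 psi i Hw HP0); apply in_app_iff; auto).
  rewrite Hb' in H1.
  assert (HBge : eval_bracket (BVar psi) i <= eval_bracket (Box psi) i).
  { change (eval_bracket (Box psi) i) with (eval RelM VM (Box psi) i).
    apply (eval_Box_ge nat RelM VM r r_ge0 VM_bounded psi i).
    - exists k. apply H2. apply HR; auto.
    - intros y Hy. specialize (H3 i y HCi Hy). rewrite HR in H3. apply rel_on_succs in H3.
      assert (HM : holds eval_bracket (mkI [(psi, y)] false [(BVar psi, i)]))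
        by (apply H1; apply in_app_iff; right; apply in_app_iff; right;
            apply in_map_iff; exists y; auto).
      apply holds_single in HM. rewrite (eval_bracket_pure psi y Hpsi) in HM. exact HM. }
  repeat split.
  - intros P HP. destruct (hasL psi i (NI P, true)) eqn:E.
    + pose proof (H1 _ (proj2 (in_app_iff _ _ _) (or_intror (proj2 (in_app_iff _ _ _)
        (or_introl (in_concl6_intro psi i b P HP E)))))) as HQ.
      unfold holds in HQ |- *; simpl in HQ.
      pose proof (sumv_repl_ge eval_bracket psi i (lhs P) HBge). destruct (strict P); lra.
    + apply H1. apply in_app_iff; left. apply in_deact_false; auto.
  - intros x y H. apply H2. apply HR; auto.
  - intros x y Hx Hr. apply HR. auto.
Qed.

Lemma models_branch_step4 Cs i b b' : step4 i b b' -> ~ Cs i ->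
  models_branch Cs b' -> models_branch Cs b.
Proof.
  intros [[Hbx [k [Hf ->]]]|[_ ->]] HCi [H1 [H2 H3]]; [|repeat split; auto].
  repeat split.
  - intros P HP. apply H1. apply in_app_iff; auto.
  - intros x y H. apply H2. apply rel_on_app; auto.
  - intros x y Hx Hr. specialize (H3 x y Hx Hr). apply rel_on_add_rel in H3.
    destruct H3 as [H3|[-> _]]; [auto|contradiction].
Qed.

End Countermodel.

Definition expanded (b : branch) (x : nat) : Prop :=
  exists y, rel_on b x y /\ (x, y) <> (1%nat, 2%nat).

Lemma rtc_backward_inv {X : Type} (st : X -> X -> Prop) (Inv G : X -> Prop) :
  (forall b b', st b b' -> Inv b -> Inv b') ->
  (forall b b', st b b' -> Inv b -> G b' -> G b) ->
  forall b b', clos_refl_trans_1n _ st b b' -> Inv b -> G b' -> G b.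
Proof. intros H1 H2 b b' Hc. induction Hc; eauto. Qed.

Lemma rel_on_rtc_step5 i b b' x y :
  clos_refl_trans_1n _ (step5_one i) b b' -> rel_on b x y -> rel_on b' x y.
Proof.
  apply (rtc_forward _ (fun b => rel_on b x y)). intros b1 b2 H Hs.
  eapply rel_on_step5_one_old; eauto.
Qed.

Lemma rel_on_rtc_step6 i b b' x y :
  clos_refl_trans_1n _ (step6_one i) b b' -> rel_on b x y -> rel_on b' x y.
Proof.
  apply (rtc_forward _ (fun b => rel_on b x y)). intros b1 b2 H Hs.
  apply (rel_on_step6_one i b1 b2 x y Hs); auto.
Qed.

Lemma models_branch_rtc_step6 RelM VM vB r phi Cs i k b5 b6 :
  0 <= r -> (forall p x, Rabs (VM p x) <= r) ->
  clos_refl_trans_1n _ (step6_one i) b5 b6 -> Cs i -> wf_branch phi b5 -> rel_on b5 i k ->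
  models_branch RelM VM vB Cs b6 -> models_branch RelM VM vB Cs b5.
Proof.
  intros hr hV H6 HCi W5 Hk.
  apply (rtc_backward_inv (step6_one i) (fun b => wf_branch phi b /\ rel_on b i k)
           (models_branch RelM VM vB Cs)); auto.
  - intros b b' Hs [Hw Hik]. split; [apply (step6_one_wf_branch phi i b b' Hs Hw)|].
    apply (rel_on_step6_one i b b' i k Hs); auto.
  - intros b b' Hs [Hw Hik] HG. apply (models_branch_step6_one RelM VM vB r hr hV phi Cs i b b' Hs);
      [auto|exists k; auto|exact (wf_admissible _ _ Hw)|auto].
Qed.

Lemma models_branch_rtc_step5 RelM VM vB r phi Cs i b4 b5 :
  0 <= r -> (forall p x, Rabs (VM p x) <= r) ->
  clos_refl_trans_1n _ (step5_one i) b4 b5 -> ~ Cs i -> wf_branch phi b4 ->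
  models_branch RelM VM vB Cs b5 -> models_branch RelM VM vB Cs b4.
Proof.
  intros hr hV H5 HCi W4.
  apply (rtc_backward_inv (step5_one i) (wf_branch phi) (models_branch RelM VM vB Cs)); auto.
  - intros b b' Hs Hw. apply (step5_one_wf_branch phi i b b' Hs Hw).
  - intros b b' Hs Hw HG.
    exact (models_branch_step5_one RelM VM vB r hr hV phi _ i b b' Hs HCi
             (wf_admissible _ _ Hw) HG).
Qed.

(* Label [i] becomes expanded during its round; the box steps at [i] are justified by the
   model because from then on [i] gets no new successors. *)
Lemma models_branch_round RelM VM vB r phi i b3 b6 : 0 <= r -> (forall p x, Rabs (VM p x) <= r) ->
  round_inv phi b3 -> exhausted_branch b3 -> round i b3 b6 ->
  models_branch RelM VM vB (expanded b6) b6 -> models_branch RelM VM vB (expanded b3) b3.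
Proof.
  intros hr hV Kb Hex Hr HB.
  destruct (classic (has_box_at i b3)) as [Hbx|Hn].
  2:{ destruct Hr as [b4 [b5 [H4 [H5 H6]]]]. rewrite (round_without_box i b3 b4 b5 b6) in HB; auto.
  }
  assert (NC : ~ expanded b3 i).
  { intros [y [Hy Hne]]. exact (ri_modal_root _ _ Kb i y Hy Hne (has_box_at_modal_at i b3 Hbx)). }
  pose proof (ri_wf _ _ Kb) as W3.
  destruct Hr as [b4 [b5 [H4 [[H5 _] [H6 _]]]]].
  destruct H4 as [[_ [k [Hf E4]]]|[Hn _]]; [|contradiction]. subst b4.
  assert (W4 : wf_branch phi (b3 ++ [(NR i k, false)])) by (apply step4_wf_branch; auto).
  assert (Hk4 : rel_on (b3 ++ [(NR i k, false)]) i k) by (apply rel_on_add_rel; auto).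
  assert (W5 : wf_branch phi b5)
    by exact (rtc_forward _ _ (fun b b' H Hs => step5_one_wf_branch phi i b b' Hs H) _ _ H5 W4).
  set (Cs6 := fun x => expanded b3 x \/ x = i).
  assert (HB6 : models_branch RelM VM vB Cs6 b6).
  { apply (models_branch_weaken _ _ _ (expanded b6)); auto. intros x [[y [Hy Hne]] | ->].
    - exists y. split; auto. apply (rel_on_rtc_step6 i b5); auto.
      apply (rel_on_rtc_step5 i (b3 ++ [(NR i k, false)])); auto. apply rel_on_app; auto.
    - exists k.
      split; [apply (rel_on_rtc_step6 i b5), (rel_on_rtc_step5 i (b3 ++ [(NR i k, false)])); auto|].
      intros E. injection E as -> ->. exact (Hf (proj2 (rel_on_labels b3 1 2 (wf_root _ _ W3)))). }
  assert (HB5 : models_branch RelM VM vB Cs6 b5).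
  { apply (models_branch_rtc_step6 RelM VM vB r phi Cs6 i k b5 b6 hr hV); auto.
    - right; auto.
    - apply (rel_on_rtc_step5 i (b3 ++ [(NR i k, false)])); auto. }
  assert (HB4 : models_branch RelM VM vB (expanded b3) (b3 ++ [(NR i k, false)])).
  { apply (models_branch_rtc_step5 RelM VM vB r phi _ i _ b5 hr hV); auto.
    apply (models_branch_weaken _ _ _ Cs6); auto. intros x Hx; left; auto. }
  apply (models_branch_step4 RelM VM vB _ i b3 (b3 ++ [(NR i k, false)])); auto.
  left. split; auto. exists k; auto.
Qed.

Definition branch_lfs (b : branch) : list lf :=
  flat_map (fun n => match n with NI P => lhs P ++ rhs P | NR _ _ => [] end) (bnodes b).

(* The countermodel read off a solution [v] of an open final branch: worlds are labels, edges
   are the relations of the branch, and a variable is worth its value under [v] where it occurs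
   on the branch and 0 elsewhere, so that the valuation is bounded. *)
Definition solution_val (v : form -> nat -> R) (b : branch) (p x : nat) : R :=
  if in_dec lf_dec (Var p, x) (branch_lfs b) then v (Var p) x else 0.

Definition solution_bound (v : form -> nat -> R) (b : branch) : R :=
  fold_right (fun y acc => Rabs (v (fst y) (snd y)) + acc) 0 (branch_lfs b).

Lemma solution_bound_ge0 v b : 0 <= solution_bound v b.
Proof.
  unfold solution_bound. induction (branch_lfs b); simpl; [lra|].
  pose proof (Rabs_pos (v (fst a) (snd a))). lra.
Qed.

Lemma solution_val_bounded v b p x : Rabs (solution_val v b p x) <= solution_bound v b.
Proof.
  unfold solution_val. destruct (in_dec lf_dec (Var p, x) (branch_lfs b)) as [H|H].
  - apply (le_sum_nonneg (fun y => Rabs (v (fst y) (snd y))) (branch_lfs b) (Var p, x)); auto.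
    intros; apply Rabs_pos.
  - rewrite Rabs_R0. apply solution_bound_ge0.
Qed.

Lemma models_final_branch bF v :
  (forall P y, In (NI P, true) bF -> In y (lhs P ++ rhs P) -> cplx (fst y) = 0%nat) ->
  (forall P, In P (ineqs_of (bnodes bF)) ->
     (forall x, In x (lhs P ++ rhs P) -> atomLK' (fst x)) -> holds v P) ->
  models_branch (rel_on bF) (solution_val v bF) (fun a x => v (BVar a) x) (expanded bF) bF.
Proof.
  intros Hc Hv. repeat split; auto. intros P HP.
  assert (HPin : In P (ineqs_of (bnodes bF))).
  { apply in_flat_map. exists (NI P). split; [apply in_bnodes; eauto|simpl; auto]. }
  assert (Hat : forall x, In x (lhs P ++ rhs P) -> atomLK' (fst x)).
  { intros [f l] Hx. specialize (Hc P (f, l) HP Hx). destruct f; simpl in *; auto; discriminate. }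
  specialize (Hv P HPin Hat). unfold holds in *.
  enough (E : forall l, incl l (lhs P ++ rhs P) ->
    sumv (eval_bracket (rel_on bF) (solution_val v bF) (fun a x => v (BVar a) x)) l = sumv v l)
    by (rewrite !E; auto; intros y Hy; apply in_app_iff; auto).
  intros l Hl. apply sumv_ext. intros [f x] Hx. specialize (Hl _ Hx).
  pose proof (Hat _ Hl) as Ha. destruct f; simpl in Ha; try contradiction; simpl; auto.
  unfold solution_val. destruct (in_dec lf_dec (Var n, x) (branch_lfs bF)) as [_|Hn]; auto.
  exfalso. apply Hn. apply in_flat_map. exists (NI P). split; [apply in_bnodes; eauto|auto].
Qed.

Definition bounded_model_of (phi : form) (b : branch) : Prop :=
  round_inv phi b -> exists RelM VM vB r, 0 <= r /\ (forall p x, Rabs (VM p x) <= r) /\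
    models_branch RelM VM vB (expanded b) b.

Definition open_branches_traced (phi : form) (S F : state) : Prop :=
  forall bF, In bF F -> sat_sys atomLK' (ineqs_of (bnodes bF)) ->
  exists b, In b S /\ bounded_model_of phi b.

Lemma open_branches_traced_stop phi F : all_cplx0 F -> open_branches_traced phi F F.
Proof.
  intros Hc bF HF [v Hv]. exists bF. split; auto. intros _.
  exists (rel_on bF), (solution_val v bF), (fun a x => v (BVar a) x), (solution_bound v bF).
  split; [apply solution_bound_ge0|]. split; [apply solution_val_bounded|].
  apply models_final_branch; auto. intros P y HP Hy. eapply Hc; eauto.
Qed.

Lemma bounded_model_of_pstep phi b bs b' : pstep b bs -> In b' bs ->
  bounded_model_of phi b' -> bounded_model_of phi b.
Proof.
  intros Hp Hb' Hg Kb.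
  destruct (Hg (pstep_round_inv phi b bs b' Hp Hb' Kb)) as [RelM [VM [vB [r [hr [hV HB]]]]]].
  exists RelM, VM, vB, r. split; auto. split; auto.
  apply (models_branch_pstep RelM VM vB phi _ b bs b' Hp Hb' (wf_admissible _ _ (ri_wf _ _ Kb))).
  apply (models_branch_weaken _ _ _ (expanded b')); auto. intros x [y [Hy Hne]]. exists y.
  split; auto. apply (rel_on_succs_ext _ _ (pstep_succs b bs b' Hp Hb')); auto.
Qed.

Lemma open_branches_traced_gstep3 phi S S' F : gstep3 S S' ->
  open_branches_traced phi S' F -> open_branches_traced phi S F.
Proof.
  intros [S1 b S2 bs Hp] HC bF HF Hs. destruct (HC bF HF Hs) as [b' [Hb' Hg]].
  rewrite !in_app_iff in Hb'. destruct Hb' as [H|[H|H]].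
  - exists b'. rewrite in_app_iff. auto.
  - exists b. split; [apply in_app_iff; simpl; auto|]. eapply bounded_model_of_pstep; eauto.
  - exists b'. rewrite in_app_iff. simpl. auto.
Qed.

Lemma Forall2_in_r {A B : Type} (Rl : A -> B -> Prop) l1 l2 y :
  Forall2 Rl l1 l2 -> In y l2 -> exists x, In x l1 /\ Rl x y.
Proof.
  induction 1; [intros []|]. intros [->|Hy]; [exists x; simpl; auto|].
  destruct (IHForall2 Hy) as [z [Hz Hr]]. exists z; simpl; auto.
Qed.

Lemma open_branches_traced_step456 phi i S3 S6 F : step456 i S3 S6 -> prop_exhausted S3 ->
  open_branches_traced phi S6 F -> open_branches_traced phi S3 F.
Proof.
  intros H456 Hpex HC bF HF Hs. destruct (HC bF HF Hs) as [b6 [Hb6 Hg]].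
  destruct (Forall2_in_r _ _ _ b6 H456 Hb6) as [b3 [Hb3 Hr]].
  exists b3. split; auto. intros Kb.
  assert (Hex : exhausted_branch b3) by (intros P x HP Hx; eapply Hpex; eauto).
  destruct (Hg (round_preserves_inv phi i b3 b6 Kb Hex Hr)) as [RelM [VM [vB [r [hr [hV HB]]]]]].
  exists RelM, VM, vB, r. split; auto. split; auto. eapply models_branch_round; eauto.
Qed.

Lemma open_branches_traced_run phi S F : complete_run S F -> open_branches_traced phi S F.
Proof.
  induction 1 as [S Hs|S S3 S6 F Hn H3 Hex Hor Hr IH]; [apply open_branches_traced_stop; auto|].
  apply (rtc_backward _ _ (fun S S' Hs => open_branches_traced_gstep3 phi S S' F Hs) S S3 H3).
  destruct Hor as [[i [_ H456]]|[_ ->]]; auto. eapply open_branches_traced_step456; eauto.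
Qed.

Lemma round_inv_init phi : pure phi ->
  round_inv phi [(NI (mkI [] true [(phi, 1%nat)]), true); (NR 1 2, false)].
Proof.
  intros Hp.
  assert (HR : forall x y, rel_on [(NI (mkI [] true [(phi, 1%nat)]), true); (NR 1 2, false)] x y ->
                 x = 1%nat /\ y = 2%nat).
  { intros x y H. unfold rel_on in H. simpl in H. destruct H as [H|[H|[]]]; [discriminate|].
    injection H; auto. }
  assert (Hm : forall x, modal_at [(NI (mkI [] true [(phi, 1%nat)]), true); (NR 1 2, false)] x ->
                 x = 1%nat).
  { intros x [P [y [HP [Hy [Hyx _]]]]]. simpl in HP. destruct HP as [HP|[HP|[]]]; [|discriminate].
    injection HP as <-. simpl in Hy. destruct Hy as [<-|[]]. auto. }
  constructor; [constructor| |].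
  - intros P m HP y Hy. simpl in HP. destruct HP as [HP|[HP|[]]]; [|discriminate].
    injection HP as <- _. simpl in Hy. destruct Hy as [<-|[]]. left. split; auto.
    apply subformulas_refl.
  - intros x x' y H1 H2. destruct (HR x y H1) as [-> _]. destruct (HR x' y H2) as [-> _]. auto.
  - intros x y H. destruct (HR x y H) as [-> ->]. split; discriminate.
  - unfold rel_on. simpl. auto.
  - intros x. simpl. destruct (PeanoNat.Nat.eqb x 1); simpl; repeat constructor; simpl; auto.
  - intros x y H Hx. destruct (HR x y H) as [-> ->]. split.
    + intros H2. specialize (Hm 2%nat H2). discriminate.
    + intros z Hz. destruct (HR 2%nat z Hz) as [E _]. discriminate.
  - intros x y H Hne. destruct (HR x y H) as [-> ->]. contradiction.
Qed.

Theorem valid_complete_run_closed phi F : pure phi -> KA_valid phi ->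
  complete_run (init_state phi) F -> closed' F.
Proof.
  intros Hp Hv Hr. apply Forall_forall. intros bF HF Hs.
  destruct (open_branches_traced_run phi _ _ Hr bF HF Hs) as [b [[<-|[]] Hg]].
  destruct (Hg (round_inv_init phi Hp)) as [RelM [VM [vB [r [hr [hV [H1 _]]]]]]].
  specialize (H1 _ (or_introl eq_refl)). unfold holds in H1. simpl in H1.
  unfold sumv in H1. simpl in H1. rewrite eval_bracket_pure in H1 by auto.
  specialize (Hv nat RelM VM r hr hV 1%nat). lra.
Qed.

(** * Termination of the complete LK'(A) procedure *)

Close Scope R_scope.

(* With [c = length (box_args phi) + 4], [3 ^ c] exceeds the number of
   successors of a label when (□▷') is applied to it, so the inequations (□▷') adds weigh
   less than the boxes it removes. *)
Fixpoint weight (c : nat) (f : form) : nat :=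
  match f with
  | Var _ | BVar _ => 0
  | Zero => 1
  | Conj a b | Disj a b | Amp a b | Imp a b => 1 + weight c a + weight c b
  | Box a => c + weight c a
  end.

Definition weight_lfs (c : nat) (l : list lf) : nat := list_sum (map (fun x => weight c (fst x)) l).
Definition weight_ineq (c : nat) (P : ineq) : nat := weight_lfs c (lhs P) + weight_lfs c (rhs P).
Definition weight_mnode (c : nat) (m : mnode) : nat :=
  match m with (NI P, true) => 3 ^ weight_ineq c P | _ => 0 end.
Definition branch_weight (c : nat) (b : branch) : nat := list_sum (map (weight_mnode c) b).
Definition state_weight (c : nat) (S : state) : nat :=
  list_sum (map (fun b => 3 ^ branch_weight c b) S).

Lemma weight_lfs_cons c x l : weight_lfs c (x :: l) = weight c (fst x) + weight_lfs c l.
Proof. reflexivity. Qed.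

Lemma weight_lfs_perm c l l' : Permutation l l' -> weight_lfs c l = weight_lfs c l'.
Proof. intros H. apply Permutation_list_sum, Permutation_map; auto. Qed.

Lemma branch_weight_app c b1 b2 :
  branch_weight c (b1 ++ b2) = branch_weight c b1 + branch_weight c b2.
Proof. unfold branch_weight. rewrite map_app, list_sum_app. reflexivity. Qed.

Lemma branch_weight_cons c m b : branch_weight c (m :: b) = weight_mnode c m + branch_weight c b.
Proof. reflexivity. Qed.

Lemma state_weight_app c S1 S2 : state_weight c (S1 ++ S2) = state_weight c S1 + state_weight c S2.
Proof. unfold state_weight. rewrite map_app, list_sum_app. reflexivity. Qed.

Lemma state_weight_cons c b S : state_weight c (b :: S) = 3 ^ branch_weight c b + state_weight c S.
Proof. reflexivity. Qed.

Lemma weight_mnode_inactive c n : weight_mnode c (n, false) = 0.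
Proof. destruct n; reflexivity. Qed.

Lemma pow3_succ_le a b : a < b -> 3 * 3 ^ a <= 3 ^ b.
Proof.
  intros H. replace (3 * 3 ^ a) with (3 ^ (a + 1)) by (rewrite Nat.pow_add_r; simpl; lia).
  apply Nat.pow_le_mono_r; lia.
Qed.

Lemma pow3_split a d b : a + d <= b -> 3 ^ a + (3 ^ d - 1) <= 3 ^ b.
Proof.
  intros H. assert (H1 : 3 ^ (a + d) <= 3 ^ b) by (apply Nat.pow_le_mono_r; lia).
  rewrite Nat.pow_add_r in H1. pose proof (Nat.pow_nonzero 3 a). pose proof (Nat.pow_nonzero 3 d).
  nia.
Qed.

Lemma pow3_gt n : n < 3 ^ n.
Proof. induction n; simpl; lia. Qed.

Lemma prop_app_weight_lt c P a : prop_app P a ->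
  forall q, In q (alt_concls a) -> weight_ineq c q < weight_ineq c P.
Proof.
  intros [P' [Hl [Hr [_ Hrule]]]] q Hq.
  replace (weight_ineq c P) with (weight_ineq c P')
    by (unfold weight_ineq; rewrite (weight_lfs_perm c _ _ Hl), (weight_lfs_perm c _ _ Hr); auto).
  destruct Hrule; simpl in Hq;
    repeat match goal with H : _ \/ _ |- _ => destruct H | H : False |- _ => destruct H end; subst;
    unfold weight_ineq; cbn [lhs rhs]; rewrite ?weight_lfs_cons; cbn [fst weight]; lia.
Qed.

Lemma branch_weight_acts c cs :
  branch_weight c (map act cs) = list_sum (map (fun q => 3 ^ weight_ineq c q) cs).
Proof. induction cs; simpl; auto. rewrite branch_weight_cons, IHcs. reflexivity. Qed.

Lemma branch_choice_weight_lt c P a cs : prop_app P a -> branch_choice a cs ->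
  list_sum (map (fun q => 3 ^ weight_ineq c q) cs) < 3 ^ weight_ineq c P.
Proof.
  intros Ha Hc.
  assert (Hb : forall q, In q cs -> 3 * 3 ^ weight_ineq c q <= 3 ^ weight_ineq c P)
    by (intros q Hq; apply pow3_succ_le, (prop_app_weight_lt c P a Ha),
          (branch_choice_incl a cs Hc); auto).
  assert (Hlen : length cs <= 2).
  { destruct Ha as [P' [_ [_ [_ Hrule]]]]. destruct a; simpl in Hc;
      [subst; inversion Hrule; simpl; lia|destruct Hc; subst; simpl; lia]. }
  pose proof (Nat.pow_nonzero 3 (weight_ineq c P)).
  destruct cs as [|q1 [|q2 [|q3 cs]]]; simpl in *; try lia.
  - specialize (Hb q1 (or_introl eq_refl)). lia.
  - pose proof (Hb q1 (or_introl eq_refl)). pose proof (Hb q2 (or_intror (or_introl eq_refl))). lia.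
Qed.

Lemma pstep_branch_weight_lt c b bs b' : pstep b bs -> In b' bs ->
  branch_weight c b' < branch_weight c b.
Proof.
  intros Hp Hb'. destruct (pstep_inv b bs b' Hp Hb') as [b1 [b2 [P [a [cs [-> [-> [Ha Hc]]]]]]]].
  rewrite !branch_weight_app, !branch_weight_cons, branch_weight_app, branch_weight_acts.
  rewrite weight_mnode_inactive. pose proof (branch_choice_weight_lt c P a cs Ha Hc). simpl. lia.
Qed.

Lemma branch_weight_deact_le c (h : mnode -> bool) (Fm : mnode -> list mnode) b :
  (forall m, In m b -> h m = true -> branch_weight c (Fm m) <= weight_mnode c m) ->
  branch_weight c (deact h b) + branch_weight c (flat_map (fun m => if h m then Fm m else []) b)
    <= branch_weight c b.
Proof.
  induction b as [|m b IH]; intros H; simpl; [lia|].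
  unfold deact in *. simpl. rewrite branch_weight_app, !branch_weight_cons.
  assert (IH' := IH (fun m' Hm' => H m' (or_intror Hm'))).
  destruct (h m) eqn:E.
  - rewrite weight_mnode_inactive. specialize (H m (or_introl eq_refl) E). lia.
  - simpl. lia.
Qed.

Lemma branch_weight_deact_lt c (h : mnode -> bool) (Fm : mnode -> list mnode) b D :
  (forall m, In m b -> h m = true -> branch_weight c (Fm m) + D <= weight_mnode c m) ->
  (exists m, In m b /\ h m = true) ->
  branch_weight c (deact h b) + branch_weight c (flat_map (fun m => if h m then Fm m else []) b) + D
    <= branch_weight c b.
Proof.
  induction b as [|m b IH]; intros H [m0 [Hm0 Hh0]]; [destruct Hm0|].
  unfold deact in *. simpl. rewrite branch_weight_app, !branch_weight_cons.
  destruct (h m) eqn:E.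
  - rewrite weight_mnode_inactive. pose proof (H m (or_introl eq_refl) E).
    pose proof (branch_weight_deact_le c h Fm b
      (fun m' Hm' Hh => ltac:(specialize (H m' (or_intror Hm') Hh); lia))).
    unfold deact in H1. lia.
  - simpl. destruct Hm0 as [->|Hm0]; [congruence|].
    pose proof (IH (fun m' Hm' => H m' (or_intror Hm')) (ex_intro _ m0 (conj Hm0 Hh0))). lia.
Qed.

Lemma weight_lfs_repl_le c psi i l : weight_lfs c (repl psi i l) <= weight_lfs c l.
Proof.
  induction l as [|x l IH]; [apply le_n|].
  change (repl psi i (x :: l))
    with ((if lf_eqb x (Box psi, i) then (BVar psi, i) else x) :: repl psi i l).
  rewrite !weight_lfs_cons. destruct (lf_eqb x (Box psi, i)) eqn:E; simpl; [|lia].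
  apply lf_eqb_true in E. subst. simpl. lia.
Qed.

Lemma weight_lfs_repl_lt c psi i l : In (Box psi, i) l ->
  weight_lfs c (repl psi i l) + (c + weight c psi) <= weight_lfs c l.
Proof.
  induction l as [|x l IH]; intros Hin; [destruct Hin|].
  change (repl psi i (x :: l))
    with ((if lf_eqb x (Box psi, i) then (BVar psi, i) else x) :: repl psi i l).
  rewrite !weight_lfs_cons. destruct (lf_eqb x (Box psi, i)) eqn:E.
  - apply lf_eqb_true in E. subst. simpl. pose proof (weight_lfs_repl_le c psi i l). lia.
  - destruct Hin as [->|Hin]; [rewrite (proj2 (lf_eqb_true _ _) eq_refl) in E; discriminate|].
    specialize (IH Hin). lia.
Qed.

Lemma step5_one_branch_weight_lt c i b b' : 1 <= c -> step5_one i b b' ->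
  branch_weight c b' < branch_weight c b.
Proof.
  intros Hc [psi [j [Hex [Hf ->]]]].
  set (D := 3 ^ (c + weight c psi) - 1).
  assert (Hm : 3 ^ weight c psi < D).
  { unfold D. rewrite Nat.pow_add_r. assert (3 <= 3 ^ c) by (apply (Nat.pow_le_mono_r 3 1 c); lia).
    pose proof (Nat.pow_nonzero 3 (weight c psi)). nia. }
  assert (Hs : forall m, In m b -> hasR psi i m = true ->
     branch_weight c (match fst m with
                      | NI P => [act (mkI (lhs P) (strict P) (repl psi i (rhs P)))]
                      | NR _ _ => [] end) + D <= weight_mnode c m).
  { intros m Hm' E. apply hasR_true in E. destruct E as [P [-> HP]]. simpl.
    unfold branch_weight. simpl. rewrite Nat.add_0_r. unfold D.
    apply pow3_split. unfold weight_ineq. simpl.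
    pose proof (weight_lfs_repl_lt c psi i (rhs P) HP). lia. }
  apply existsb_exists in Hex.
  pose proof (branch_weight_deact_lt c (hasR psi i) (fun m => match fst m with
    | NI P => [act (mkI (lhs P) (strict P) (repl psi i (rhs P)))] | NR _ _ => [] end) b D Hs Hex).
  cbv beta in H.
  assert (Hmk : weight_mnode c (act (mkI [(BVar psi, i)] false [(psi, j)])) = 3 ^ weight c psi)
    by (unfold weight_mnode, act, weight_ineq, weight_lfs; simpl; f_equal; lia).
  rewrite !branch_weight_app, !branch_weight_cons, weight_mnode_inactive, Hmk. unfold concl5.
  change (branch_weight c []) with 0. lia.
Qed.

Lemma step6_one_branch_weight_lt c i b b' : length (succs i b) + 2 <= 3 ^ c -> step6_one i b b' ->
  branch_weight c b' < branch_weight c b.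
Proof.
  intros Hc [psi [Hex ->]].
  set (D := 3 ^ (c + weight c psi) - 1).
  assert (Hmk : branch_weight c
                  (map (fun j => act (mkI [(psi, j)] false [(BVar psi, i)])) (succs i b))
                = length (succs i b) * 3 ^ weight c psi).
  { generalize (succs i b). intros l. induction l as [|j l IH]; [reflexivity|].
    simpl map. rewrite branch_weight_cons, IH. simpl length.
    unfold weight_mnode, act, weight_ineq, weight_lfs; simpl. rewrite !Nat.add_0_r. reflexivity. }
  assert (Hm : length (succs i b) * 3 ^ weight c psi < D).
  { unfold D. rewrite Nat.pow_add_r. pose proof (Nat.pow_nonzero 3 (weight c psi)). nia. }
  assert (Hs : forall m, In m b -> hasL psi i m = true ->
     branch_weight c (match fst m with
                      | NI P => [act (mkI (repl psi i (lhs P)) (strict P) (rhs P))]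
                      | NR _ _ => [] end) + D <= weight_mnode c m).
  { intros m Hm' E. apply hasL_true in E. destruct E as [P [-> HP]]. simpl.
    unfold branch_weight. simpl. rewrite Nat.add_0_r. unfold D.
    apply pow3_split. unfold weight_ineq. simpl.
    pose proof (weight_lfs_repl_lt c psi i (lhs P) HP). lia. }
  apply existsb_exists in Hex.
  pose proof (branch_weight_deact_lt c (hasL psi i) (fun m => match fst m with
    | NI P => [act (mkI (repl psi i (lhs P)) (strict P) (rhs P))] | NR _ _ => [] end) b D Hs Hex).
  cbv beta in H.
  rewrite !branch_weight_app, Hmk. unfold concl6. lia.
Qed.

Lemma rtc_trans {X : Type} (st : X -> X -> Prop) a b d :
  clos_refl_trans_1n _ st a b -> clos_refl_trans_1n _ st b d -> clos_refl_trans_1n _ st a d.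
Proof. induction 1; eauto using clos_refl_trans_1n. Qed.

Lemma rtc_gstep3_context A T T' C : clos_refl_trans_1n _ gstep3 T T' ->
  clos_refl_trans_1n _ gstep3 (A ++ T ++ C) (A ++ T' ++ C).
Proof.
  induction 1 as [|T T1 T' Hs Hc IH]; [constructor|].
  econstructor; [|exact IH]. destruct Hs as [S1 b S2 bs Hp].
  replace (A ++ (S1 ++ b :: S2) ++ C) with ((A ++ S1) ++ b :: (S2 ++ C))
    by (rewrite <- !app_assoc; reflexivity).
  replace (A ++ (S1 ++ bs ++ S2) ++ C) with ((A ++ S1) ++ bs ++ (S2 ++ C))
    by (rewrite <- !app_assoc; reflexivity).
  constructor; auto.
Qed.

Lemma rtc_gstep3_each (Good : branch -> Prop) c S :
  (forall b, In b S -> exists T, clos_refl_trans_1n _ gstep3 [b] T /\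
     (forall b', In b' T -> Good b') /\ state_weight c T <= 3 ^ branch_weight c b) ->
  exists T, clos_refl_trans_1n _ gstep3 S T /\ (forall b', In b' T -> Good b') /\
    state_weight c T <= state_weight c S.
Proof.
  induction S as [|b S IH]; intros H.
  - exists []. split; [constructor|split; [intros ? []|auto]].
  - destruct (H b (or_introl eq_refl)) as [T1 [H1 [G1 W1]]].
    destruct (IH (fun b' Hb' => H b' (or_intror Hb'))) as [T2 [H2 [G2 W2]]].
    exists (T1 ++ T2). split; [|split].
    + apply rtc_trans with (T1 ++ S).
      * apply (rtc_gstep3_context [] [b] T1 S). auto.
      * pose proof (rtc_gstep3_context T1 S T2 [] H2) as E. rewrite !app_nil_r in E. exact E.
    + intros b' Hb'. apply in_app_iff in Hb'. destruct Hb'; auto.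
    + rewrite state_weight_app, state_weight_cons. lia.
Qed.

Lemma prop_rule_applies P x : In x (lhs P ++ rhs P) -> ~ is_box_or_atom (fst x) ->
  exists a, prop_app P a.
Proof.
  intros Hx Hn. destruct P as [l s r]. simpl in Hx. apply in_app_iff in Hx.
  destruct Hx as [Hx|Hx]; apply in_split in Hx; destruct Hx as [l1 [l2 ->]].
  - assert (Hr : exists a, prop_rule (mkI (x :: l1 ++ l2) s r) a)
      by (destruct x as [[] i]; simpl in Hn; try (exfalso; apply Hn; exact I);
          eexists; constructor).
    destruct Hr as [a Ha]. exists a, (mkI (x :: l1 ++ l2) s r).
    simpl. split; [symmetry; apply Permutation_middle|auto].
  - assert (Hr : exists a, prop_rule (mkI l s (x :: l1 ++ l2)) a)
      by (destruct x as [[] i]; simpl in Hn; try (exfalso; apply Hn; exact I);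
          eexists; constructor).
    destruct Hr as [a Ha]. exists a, (mkI l s (x :: l1 ++ l2)).
    simpl. split; [auto|split; [symmetry; apply Permutation_middle|auto]].
Qed.

Lemma pstep_exists b : ~ exhausted_branch b -> exists bs, pstep b bs.
Proof.
  intros Hnp.
  assert (exists P x, In (NI P, true) b /\ In x (lhs P ++ rhs P) /\ ~ is_box_or_atom (fst x))
    as [P [x [HP [Hx Hnx]]]].
  { apply NNPP; intros Hne. apply Hnp. intros P x HP Hx. apply NNPP; intros Hn. apply Hne; eauto. }
  destruct (prop_rule_applies P x Hx Hnx) as [[cs|c1 c2] Ha];
    apply in_split in HP; destruct HP as [b1 [b2 ->]]; eexists; [apply ps_one|apply ps_two]; eauto.
Qed.

Lemma pstep_state_weight_lt c b bs : pstep b bs -> state_weight c bs < 3 ^ branch_weight c b.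
Proof.
  intros Hp.
  assert (Hlt : forall b', In b' bs -> branch_weight c b' < branch_weight c b)
    by (intros; eapply pstep_branch_weight_lt; eauto).
  revert Hlt.
  destruct Hp as [b1 b2 P cs Ha|b1 b2 P c1 c2 Ha]; intros Hlt; unfold state_weight; simpl.
  - rewrite Nat.add_0_r. apply Nat.pow_lt_mono_r; [lia|]. apply Hlt; simpl; auto.
  - pose proof (pow3_succ_le _ _ (Hlt _ (or_introl eq_refl))).
    pose proof (pow3_succ_le _ _ (Hlt _ (or_intror (or_introl eq_refl)))).
    pose proof (Nat.pow_nonzero 3 (branch_weight c (b1 ++ (NI P, false) :: b2 ++ [act c1]))).
    lia.
Qed.

Lemma exhaust_branch phi c b : round_inv phi b ->
  exists T, clos_refl_trans_1n _ gstep3 [b] T /\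
    (forall b', In b' T -> round_inv phi b' /\ exhausted_branch b') /\
    state_weight c T <= 3 ^ branch_weight c b.
Proof.
  remember (branch_weight c b) as n eqn:En. revert b En.
  induction n as [n IH] using lt_wf_ind. intros b -> Kb.
  destruct (classic (exhausted_branch b)) as [Hp|Hnp].
  - exists [b]. split; [constructor|split; [intros b' [<-|[]]; auto|]].
    unfold state_weight. simpl. lia.
  - destruct (pstep_exists b Hnp) as [bs Hps].
    destruct (rtc_gstep3_each (fun b' => round_inv phi b' /\ exhausted_branch b') c bs)
      as [T [H1 [H2 H3]]].
    { intros b' Hb'. apply (IH (branch_weight c b')); auto.
      - apply (pstep_branch_weight_lt c b bs b' Hps Hb').
      - apply (pstep_round_inv phi b bs b' Hps Hb' Kb). }
    exists T. split; [|split; auto].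
    + econstructor; [|exact H1]. pose proof (g3 [] b [] bs Hps) as E. rewrite app_nil_r in E.
      exact E.
    + pose proof (pstep_state_weight_lt c b bs Hps). lia.
Qed.

Definition box_args (phi : form) : list form :=
  nodup form_eq_dec (flat_map (fun f => match f with Box a => [a] | _ => [] end) (subformulas phi)).

Lemma admissible_box_args phi psi : admissible phi (Box psi) -> In psi (box_args phi).
Proof.
  intros [[_ H]|[a [E _]]]; [|discriminate].
  apply nodup_In, in_flat_map. exists (Box psi). simpl; auto.
Qed.

Definition pending_right (phi : form) (i : nat) (b : branch) : nat :=
  length (filter (fun psi => existsb (hasR psi i) b) (box_args phi)).
Definition pending_left (phi : form) (i : nat) (b : branch) : nat :=
  length (filter (fun psi => existsb (hasL psi i) b) (box_args phi)).

Lemma filter_length_lt (L : list form) (f f' : form -> bool) a : NoDup L ->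
  (forall x, f' x = true -> f x = true) -> In a L -> f a = true -> f' a = false ->
  length (filter f' L) < length (filter f L).
Proof.
  induction L as [|y L IH]; intros Hnd Himp Ha Hfa Hfa'; [destruct Ha|].
  inversion Hnd; subst. simpl. destruct Ha as [->|Ha].
  - rewrite Hfa, Hfa'. simpl.
    enough (length (filter f' L) <= length (filter f L)) by lia.
    clear -Himp. induction L as [|a L IHL]; simpl; auto.
    destruct (f' a) eqn:E; [rewrite (Himp a E); simpl; lia|]. destruct (f a); simpl; lia.
  - specialize (IH H2 Himp Ha Hfa Hfa').
    destruct (f' y) eqn:E; [rewrite (Himp y E); simpl; lia|]. destruct (f y); simpl; lia.
Qed.

Lemma filter_length_le (L : list form) f : length (filter f L) <= length L.
Proof. induction L; simpl; auto. destruct (f a); simpl; lia. Qed.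

Lemma hasR_box_args phi i b psi : wf_branch phi b -> existsb (hasR psi i) b = true ->
  In psi (box_args phi).
Proof.
  intros Wb H. apply existsb_hasR in H. destruct H as [P [HP Hx]]. apply admissible_box_args.
  apply (wf_admissible _ _ Wb P true HP (Box psi, i)). apply in_app_iff; auto.
Qed.

Lemma hasL_box_args phi i b psi : wf_branch phi b -> existsb (hasL psi i) b = true ->
  In psi (box_args phi).
Proof.
  intros Wb H. apply existsb_hasL in H. destruct H as [P [HP Hx]]. apply admissible_box_args.
  apply (wf_admissible _ _ Wb P true HP (Box psi, i)). apply in_app_iff; auto.
Qed.

Lemma not_no_box_right i b : ~ no_box_right i b -> exists psi, existsb (hasR psi i) b = true.
Proof.
  intros H. apply NNPP. intros Hn. apply H. intros psi. apply Bool.not_true_iff_false. eauto.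
Qed.

Lemma not_no_box_left i b : ~ no_box_left i b -> exists psi, existsb (hasL psi i) b = true.
Proof.
  intros H. apply NNPP. intros Hn. apply H. intros psi. apply Bool.not_true_iff_false. eauto.
Qed.

Lemma hasR_step5_one_branch i b psi j : existsb (hasR psi i) b = true -> bfresh j b ->
  let b' := deact (hasR psi i) b ++ concl5 psi i b ++
         [act (mkI [(BVar psi, i)] false [(psi, j)]); (NR i j, false)] in
  forall psi', existsb (hasR psi' i) b' = true -> psi' <> psi /\ existsb (hasR psi' i) b = true.
Proof.
  intros Hex Hf b' psi' H. apply existsb_hasR in H. destruct H as [Q [HQ HB]].
  unfold b' in HQ. rewrite !in_app_iff in HQ. destruct HQ as [HQ|[HQ|HQ]].
  - apply in_deact in HQ. destruct HQ as [m0 [Hm0 Hm]]. destruct (Hm eq_refl) as [-> E].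
    split; [|apply existsb_hasR; eauto]. intros ->.
    rewrite <- Bool.not_true_iff_false in E. apply E. simpl. apply existsb_exists.
    exists (Box psi, i). split; auto. apply lf_eqb_true; auto.
  - apply in_concl5 in HQ. destruct HQ as [P [HP [_ Heq]]]. injection Heq as ->.
    simpl in HB. apply in_repl in HB. destruct HB as [[HB Hne]|[HB _]]; [|discriminate].
    split; [intros ->; auto|apply existsb_hasR; eauto].
  - simpl in HQ. destruct HQ as [HQ|[HQ|[]]]; [|discriminate]. injection HQ as <-.
    simpl in HB. destruct HB as [HB|[]]. injection HB as _ E. subst j.
    destruct (proj1 (existsb_hasR psi i b) Hex) as [P0 [HP0 HB0]].
    exfalso. apply (bfresh_lf i b P0 true (Box psi, i) Hf HP0); auto. apply in_app_iff; auto.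
Qed.

Lemma hasL_step6_one_branch i b psi : no_self_succ i b ->
  let b' := deact (hasL psi i) b ++ concl6 psi i b ++
         map (fun j => act (mkI [(psi, j)] false [(BVar psi, i)])) (succs i b) in
  forall psi', existsb (hasL psi' i) b' = true -> psi' <> psi /\ existsb (hasL psi' i) b = true.
Proof.
  intros Hsi b' psi' H. apply existsb_hasL in H. destruct H as [Q [HQ HB]].
  unfold b' in HQ. rewrite !in_app_iff in HQ. destruct HQ as [HQ|[HQ|HQ]].
  - apply in_deact in HQ. destruct HQ as [m0 [Hm0 Hm]]. destruct (Hm eq_refl) as [-> E].
    split; [|apply existsb_hasL; eauto]. intros ->.
    rewrite <- Bool.not_true_iff_false in E. apply E. simpl. apply existsb_exists.
    exists (Box psi, i). split; auto. apply lf_eqb_true; auto.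
  - apply in_concl6 in HQ. destruct HQ as [P [HP [_ Heq]]]. injection Heq as ->.
    simpl in HB. apply in_repl in HB. destruct HB as [[HB Hne]|[HB _]]; [|discriminate].
    split; [intros ->; auto|apply existsb_hasL; eauto].
  - apply in_map_iff in HQ. destruct HQ as [j [Heq Hj]]. injection Heq as <-.
    simpl in HB. destruct HB as [HB|[]]. injection HB as _ E. exfalso; apply (Hsi j Hj); auto.
Qed.

Lemma run_step5 phi c i b : 1 <= c -> wf_branch phi b ->
  exists b5, clos_refl_trans_1n _ (step5_one i) b b5 /\ no_box_right i b5 /\ wf_branch phi b5 /\
    length (succs i b5) + pending_right phi i b5 <= length (succs i b) + pending_right phi i b /\
    (b5 = b \/ branch_weight c b5 < branch_weight c b).
Proof.
  intros Hc. remember (pending_right phi i b) as n eqn:En. revert b En.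
  induction n as [n IH] using lt_wf_ind. intros b -> Wb.
  destruct (classic (no_box_right i b)) as [HnR|HnR];
    [exists b; split; [constructor|split; [auto|split; [auto|split; [lia|left; auto]]]]|].
  destruct (not_no_box_right i b HnR) as [psi Hpsi].
  destruct (fresh_exists (bnodes b)) as [j Hj].
  set (b' := deact (hasR psi i) b ++ concl5 psi i b ++
       [act (mkI [(BVar psi, i)] false [(psi, j)]); (NR i j, false)]).
  assert (Hs : step5_one i b b') by (exists psi, j; auto).
  assert (Hcnt : pending_right phi i b' < pending_right phi i b).
  { apply (filter_length_lt _ _ _ psi); [apply NoDup_nodup| | |auto|].
    - intros psi' H. apply (hasR_step5_one_branch i b psi j Hpsi Hj psi' H).
    - apply (hasR_box_args phi i b psi Wb Hpsi).
    - apply Bool.not_true_iff_false. intros H.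
      exact (proj1 (hasR_step5_one_branch i b psi j Hpsi Hj psi H) eq_refl). }
  assert (Hsu : length (succs i b') = length (succs i b) + 1).
  { destruct (step5_one_inv i b b' Hs) as [psi0 [j0 [_ [_ [Hsu _]]]]].
    rewrite Hsu, PeanoNat.Nat.eqb_refl, length_app. simpl. lia. }
  pose proof (step5_one_branch_weight_lt c i b b' Hc Hs) as Hgb.
  destruct (IH _ Hcnt b' eq_refl (step5_one_wf_branch phi i b b' Hs Wb))
    as [b5 [H1 [H2 [H3 [H4 H5]]]]].
  exists b5. split; [econstructor; eauto|]. split; [auto|split; [auto|split; [lia|]]].
  right. destruct H5 as [->|H5]; lia.
Qed.

Lemma run_step6 phi c i b : wf_branch phi b -> length (succs i b) + 2 <= 3 ^ c ->
  exists b6, clos_refl_trans_1n _ (step6_one i) b b6 /\ no_box_left i b6 /\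
    (no_box_right i b -> no_box_right i b6) /\
    (b6 = b \/ branch_weight c b6 < branch_weight c b).
Proof.
  remember (pending_left phi i b) as n eqn:En. revert b En.
  induction n as [n IH] using lt_wf_ind. intros b -> Wb Hc.
  destruct (classic (no_box_left i b)) as [HnL|HnL];
    [exists b; split; [constructor|split; [auto|split; [auto|left; auto]]]|].
  destruct (not_no_box_left i b HnL) as [psi Hpsi].
  pose proof (wf_branch_no_self_succ phi b i Wb) as Hsi.
  set (b' := deact (hasL psi i) b ++ concl6 psi i b ++
       map (fun j => act (mkI [(psi, j)] false [(BVar psi, i)])) (succs i b)).
  assert (Hs : step6_one i b b') by (exists psi; auto).
  assert (Hcnt : pending_left phi i b' < pending_left phi i b).
  { apply (filter_length_lt _ _ _ psi); [apply NoDup_nodup| | |auto|].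
    - intros psi' H. apply (hasL_step6_one_branch i b psi Hsi psi' H).
    - apply (hasL_box_args phi i b psi Wb Hpsi).
    - apply Bool.not_true_iff_false. intros H.
      exact (proj1 (hasL_step6_one_branch i b psi Hsi psi H) eq_refl). }
  pose proof (step6_one_branch_weight_lt c i b b' Hc Hs) as Hgb.
  destruct (IH _ Hcnt b' eq_refl (step6_one_wf_branch phi i b b' Hs Wb))
    as [b6 [H1 [H2 [H3 H4]]]]; [rewrite (succs_step6_one i b b' i Hs); auto|].
  exists b6. split; [econstructor; eauto|]. split; [auto|split].
  - intros HnR. apply H3, (step6_one_no_box_right i b b' Hs HnR).
  - right. destruct H4 as [->|H4]; lia.
Qed.

Lemma length_succs_modal phi b i : round_inv phi b -> modal_at b i -> length (succs i b) <= 1.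
Proof.
  intros Kb Hi. pose proof (wf_nodup_succs _ _ (ri_wf _ _ Kb) i) as Hnd.
  assert (H2 : forall y, In y (succs i b) -> y = 2%nat).
  { intros y Hy. apply rel_on_succs in Hy. apply NNPP. intros Hy2.
    apply (ri_modal_root _ _ Kb i y Hy); auto. intros E. injection E as _ E. auto. }
  destruct (succs i b) as [|x [|y l]]; simpl; auto.
  inversion Hnd as [|? ? Hx _]. exfalso. apply Hx. rewrite (H2 x), (H2 y); simpl; auto.
Qed.

Lemma round_trivial i b : ~ has_box_at i b -> round i b b.
Proof.
  intros Hn. exists b, b. split; [right; auto|split; split; try constructor].
  - intros psi. apply Bool.not_true_iff_false. rewrite existsb_hasR. intros [P [HP Hx]].
    apply Hn. exists P, psi. split; auto. apply in_app_iff; auto.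
  - intros psi. apply Bool.not_true_iff_false. rewrite existsb_hasL. intros [P [HP Hx]].
    apply Hn. exists P, psi. split; auto. apply in_app_iff; auto.
Qed.

Lemma run_round phi c i b3 : c = (length (box_args phi) + 4)%nat ->
  round_inv phi b3 -> exhausted_branch b3 ->
  exists b6, round i b3 b6 /\ round_inv phi b6 /\ branch_weight c b6 <= branch_weight c b3 /\
    (has_box_at i b3 -> branch_weight c b6 < branch_weight c b3).
Proof.
  intros Hc Kb Hex.
  destruct (classic (has_box_at i b3)) as [Hbx|Hn].
  2:{ exists b3. split; [apply round_trivial; auto|].
      split; [auto|split; [lia|intros H; contradiction]]. }
  destruct (fresh_exists (bnodes b3)) as [k Hk].
  set (b4 := b3 ++ [(NR i k, false)]).
  assert (W4 : wf_branch phi b4) by (apply step4_wf_branch; auto; apply (ri_wf _ _ Kb)).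
  assert (Hgb4 : branch_weight c b4 = branch_weight c b3)
    by (unfold b4; rewrite branch_weight_app; simpl; unfold branch_weight at 2; simpl; lia).
  assert (Hs4 : length (succs i b4) <= 2).
  { unfold b4. rewrite succs_add_rel, PeanoNat.Nat.eqb_refl, length_app.
    pose proof (length_succs_modal phi b3 i Kb (has_box_at_modal_at i b3 Hbx)). simpl. lia. }
  destruct (run_step5 phi c i b4 ltac:(lia) W4) as [b5 [G1 [G2 [G3 [G4 G5]]]]].
  assert (Hpow : length (succs i b5) + 2 <= 3 ^ c).
  { pose proof (pow3_gt c).
    pose proof (filter_length_le (box_args phi) (fun psi => existsb (hasR psi i) b4)).
    unfold pending_right in G4. lia. }
  destruct (run_step6 phi c i b5 G3 Hpow) as [b6 [L1 [L2 [L3 L4]]]].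
  assert (Hr : round i b3 b6)
    by (exists b4, b5; split; [left; split; auto; exists k; auto|split; split; auto]).
  exists b6. split; [auto|split; [apply (round_preserves_inv phi i b3 b6 Kb Hex Hr)|]].
  enough (branch_weight c b6 < branch_weight c b3) by (split; [lia|auto]).
  destruct G5 as [E5|G5]; destruct L4 as [E6|L4]; try (subst; lia).
  subst b6 b5. exfalso. destruct Hbx as [P [psi [HP Hx]]].
  assert (HP4 : In (NI P, true) b4) by (apply ineqs_add_rel; auto).
  apply in_app_iff in Hx. destruct Hx as [Hx|Hx].
  - specialize (L2 psi). rewrite (proj2 (existsb_hasL psi i b4) (ex_intro _ P (conj HP4 Hx))) in L2.
    discriminate.
  - specialize (G2 psi). rewrite (proj2 (existsb_hasR psi i b4) (ex_intro _ P (conj HP4 Hx))) in G2.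
    discriminate.
Qed.

Lemma run_round_state phi c i S3 : c = (length (box_args phi) + 4)%nat ->
  (forall b, In b S3 -> round_inv phi b /\ exhausted_branch b) ->
  exists S6, step456 i S3 S6 /\ (forall b, In b S6 -> round_inv phi b) /\
    state_weight c S6 <= state_weight c S3 /\
    ((exists b, In b S3 /\ has_box_at i b) -> state_weight c S6 < state_weight c S3).
Proof.
  intros Hc. induction S3 as [|b S3 IH]; intros HK.
  - exists []. split; [constructor|]. split; [intros ? []|]. split; auto. intros [b [[] _]].
  - destruct (HK b (or_introl eq_refl)) as [Kb Pb].
    destruct (run_round phi c i b Hc Kb Pb) as [b6 [Hst [K6 [Hle Hlt]]]].
    destruct (IH (fun b' Hb' => HK b' (or_intror Hb'))) as [S6 [H1 [H2 [H3 H4]]]].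
    exists (b6 :: S6). split; [constructor; auto|].
    split; [intros b' [<-|Hb']; auto|].
    assert (3 ^ branch_weight c b6 <= 3 ^ branch_weight c b) by (apply Nat.pow_le_mono_r; lia).
    rewrite !state_weight_cons. split; [lia|].
    intros [b' [[E|Hb'] Hbx]].
    + subst b'. assert (3 ^ branch_weight c b6 < 3 ^ branch_weight c b)
        by (apply Nat.pow_lt_mono_r; auto). lia.
    + specialize (H4 (ex_intro _ b' (conj Hb' Hbx))). lia.
Qed.

Lemma not_all_cplx0_box S : prop_exhausted S -> ~ all_cplx0 S ->
  exists b i, In b S /\ has_box_at i b.
Proof.
  intros Hex Ha.
  assert (exists b P x, In b S /\ In (NI P, true) b /\ In x (lhs P ++ rhs P) /\
                        cplx (fst x) <> 0%nat)
    as [b [P [x [Hb [HP [Hx Hcx]]]]]].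
  { apply NNPP; intros Hne; apply Ha; intros b P x Hb HP Hx.
    destruct (PeanoNat.Nat.eq_dec (cplx (fst x)) 0); auto. exfalso; apply Hne; eauto 7. }
  pose proof (Hex b P x Hb HP Hx) as Hbx.
  destruct x as [[] l]; simpl in Hbx, Hcx; try contradiction; try lia.
  exists b, l. split; auto. exists P, f. auto.
Qed.

Lemma complete_run_exists phi c S : c = (length (box_args phi) + 4)%nat ->
  (forall b, In b S -> round_inv phi b) -> exists F, complete_run S F.
Proof.
  intros Hc. remember (state_weight c S) as n eqn:En. revert S En.
  induction n as [n IH] using lt_wf_ind. intros S -> HK.
  destruct (classic (all_cplx0 S)) as [Ha|Ha]; [exists S; apply cr_stop; auto|].
  destruct (rtc_gstep3_each (fun b => round_inv phi b /\ exhausted_branch b) c S)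
    as [S3 [G1 [G2 G3]]].
  { intros b Hb. apply exhaust_branch; auto. }
  assert (Hpex : prop_exhausted S3) by (intros b P x Hb HP Hx; eapply (proj2 (G2 b Hb)); eauto).
  destruct (classic (all_cplx0 S3)) as [Ha3|Ha3].
  { exists S3.
    exact (cr_round S S3 S3 S3 Ha G1 Hpex (or_intror (conj Ha3 eq_refl)) (cr_stop S3 Ha3)). }
  destruct (not_all_cplx0_box S3 Hpex Ha3) as [b [i [Hb Hbox]]].
  destruct (run_round_state phi c i S3 Hc G2) as [S6 [R1 [R2 [R3 R4]]]].
  specialize (R4 (ex_intro _ b (conj Hb Hbox))).
  destruct (IH (state_weight c S6) ltac:(lia) S6 eq_refl R2) as [F HF].
  exists F. apply (cr_round S S3 S6 F); auto. left. exists i. split; [exists b|]; auto.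
Qed.

Theorem valid_closed_complete_LK'_tableau (phi : form) :
  pure phi -> KA_valid phi -> closed_complete_LK'_tableau phi.
Proof.
  intros Hp Hv.
  destruct (complete_run_exists phi _ (init_state phi) eq_refl) as [F HF].
  { intros b [<-|[]]. apply round_inv_init; auto. }
  exists F. split; auto. apply (valid_complete_run_closed phi F Hp Hv HF).
Qed.

Theorem theorem3p7 (phi : form) :
  pure phi ->
  (closed_complete_LK'_tableau phi <-> LKA_derivable phi) /\
  (LKA_derivable phi <-> KA_valid phi).
Proof.
  intros Hp.
  pose proof (LK'_closed_LK_derivable phi Hp) as H12.
  pose proof (LK_derivable_valid phi) as H23.
  pose proof (valid_closed_complete_LK'_tableau phi Hp) as H31.
  tauto.
Qed.
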